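(* Let $n\in\mathbb N\cup\{\omega\}$ and $F\colon P\to Q$ a morphism of $n$-polygraphs. The following are equivalent: (i) $F$ is a monomorphism in $\mathrm{Pol}_n$; (ii) $F_k\colon P_k\to Q_k$ is injective for every $k\le n$; (iii) the induced prefunctor $F^*\colon P^*\to Q^*$ is a monomorphism in $\mathrm{PCat}_n$.
   Context: An $n$-precategory is an $n$-globular set with identities and compositions $u\ast_iv$ of $i$-composable cells satisfying the axioms of strict $n$-categories for sources/targets, units, associativity and distributivity of lower- over higher-dimensional composition, but not the interchange law; $\mathrm{PCat}_n$ is their category. An $n$-polygraph $P$ consists of sets $P_k$ ($k\le n$) of $k$-generators with sources and targets $P_{k+1}\to(P^* )_k$ satisfying globular identities, where $P^*$ denotes the free $n$-precategory obtained by inductively adjoining each generator as a cell from its source to its target. A morphism $F\colon P\to Q$ is a family $F_k\colon P_k\to Q_k$ commuting with sources and targets via the induced prefunctors $F^*$; $\mathrm{Pol}_n$ is the resulting category. *)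

From Stdlib Require Import Arith Lia.

Inductive nbar : Type := NFin (m : nat) | NOmega.

Definition leNb (k : nat) (n : nbar) : bool :=
  match n with NFin m => Nat.leb k m | NOmega => true end.
Definition leN (k : nat) (n : nbar) : Prop := leNb k n = true.

Lemma leN_le k l n : k <= l -> leN l n -> leN k n.
Proof.
  unfold leN, leNb; destruct n as [m|]; auto.
  intros H1 H2. apply Nat.leb_le in H2. apply Nat.leb_le. lia.
Qed.

Lemma leN_max k l n : leN k n -> leN l n -> leN (Nat.max k l) n.
Proof.
  unfold leN, leNb; destruct n as [m|]; auto.
  intros H1 H2. apply Nat.leb_le in H1. apply Nat.leb_le in H2.
  apply Nat.leb_le. lia.
Qed.

(* n-precategories, presented single-sorted: an n-globular set is a    *)
(* type of cells graded by a dimension function.  Equality of cells is *)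
(* a setoid equality [ceq].  Composition [comp x y] of cells of         *)
(* dimensions k, l is the composition along i = min k l - 1 (one of the *)
(* two cells is an (i+1)-cell), defined when t_i x = s_i y; its result  *)
(* has dimension max k l.                                               *)

Definition composable {C : Type} (ceq : C -> C -> Prop) (dim : C -> nat)
  (src tgt : C -> C) (x y : C) : Prop :=
  1 <= dim x /\ 1 <= dim y /\
  ceq (Nat.iter (dim x - (Nat.min (dim x) (dim y) - 1)) tgt x)
      (Nat.iter (dim y - (Nat.min (dim x) (dim y) - 1)) src y).

Record PreCat (n : nbar) : Type := {
  cell :> Type;
  ceq : cell -> cell -> Prop;
  dim : cell -> nat;
  src : cell -> cell;
  tgt : cell -> cell;
  idc : cell -> cell;
  comp : forall x y : cell, composable ceq dim src tgt x y -> cell;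
  ceq_refl : forall x, ceq x x;
  ceq_sym : forall x y, ceq x y -> ceq y x;
  ceq_trans : forall x y z, ceq x y -> ceq y z -> ceq x z;
  dim_ceq : forall x y, ceq x y -> dim x = dim y;
  src_ceq : forall x y, 1 <= dim x -> ceq x y -> ceq (src x) (src y);
  tgt_ceq : forall x y, 1 <= dim x -> ceq x y -> ceq (tgt x) (tgt y);
  idc_ceq : forall x y, leN (S (dim x)) n -> ceq x y -> ceq (idc x) (idc y);
  comp_ceq : forall x x' y y' h h', ceq x x' -> ceq y y' ->
      ceq (comp x y h) (comp x' y' h');
  dim_le : forall x, leN (dim x) n;
  dim_src : forall x, 1 <= dim x -> dim (src x) = dim x - 1;
  dim_tgt : forall x, 1 <= dim x -> dim (tgt x) = dim x - 1;
  glob_ss : forall x, 2 <= dim x -> ceq (src (src x)) (src (tgt x));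
  glob_tt : forall x, 2 <= dim x -> ceq (tgt (src x)) (tgt (tgt x));
  dim_idc : forall x, leN (S (dim x)) n -> dim (idc x) = S (dim x);
  src_idc : forall x, leN (S (dim x)) n -> ceq (src (idc x)) x;
  tgt_idc : forall x, leN (S (dim x)) n -> ceq (tgt (idc x)) x;
  dim_comp : forall x y h, dim (comp x y h) = Nat.max (dim x) (dim y);
  src_comp_eq : forall x y h, dim x = dim y -> ceq (src (comp x y h)) (src x);
  tgt_comp_eq : forall x y h, dim x = dim y -> ceq (tgt (comp x y h)) (tgt y);
  src_comp_lt : forall x y h h', dim x < dim y ->
      ceq (src (comp x y h)) (comp x (src y) h');
  tgt_comp_lt : forall x y h h', dim x < dim y ->
      ceq (tgt (comp x y h)) (comp x (tgt y) h');
  src_comp_gt : forall x y h h', dim y < dim x ->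
      ceq (src (comp x y h)) (comp (src x) y h');
  tgt_comp_gt : forall x y h h', dim y < dim x ->
      ceq (tgt (comp x y h)) (comp (tgt x) y h');
  unit_l : forall x i h, i < dim x ->
      ceq (comp (idc (Nat.iter (dim x - i) src x)) x h) x;
  unit_r : forall x i h, i < dim x ->
      ceq (comp x (idc (Nat.iter (dim x - i) tgt x)) h) x;
  idc_comp_l : forall x y h h', dim y <= dim x -> leN (S (dim x)) n ->
      ceq (idc (comp x y h)) (comp (idc x) y h');
  idc_comp_r : forall x y h h', dim x <= dim y -> leN (S (dim y)) n ->
      ceq (idc (comp x y h)) (comp x (idc y) h');
  (* associativity (all four compositions along the same i) *)
  assoc : forall x y z h1 h2 h3 h4,
      Nat.min (dim x) (dim y) = Nat.min (dim y) (dim z) ->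
      Nat.min (Nat.max (dim x) (dim y)) (dim z) = Nat.min (dim x) (dim y) ->
      Nat.min (dim x) (Nat.max (dim y) (dim z)) = Nat.min (dim x) (dim y) ->
      ceq (comp (comp x y h1) z h2) (comp x (comp y z h3) h4);
  distr_l : forall x y z h1 h2 h3 h4 h5, dim x < Nat.min (dim y) (dim z) ->
      ceq (comp x (comp y z h1) h2) (comp (comp x y h3) (comp x z h4) h5);
  distr_r : forall x y z h1 h2 h3 h4 h5, dim x < Nat.min (dim y) (dim z) ->
      ceq (comp (comp y z h1) x h2) (comp (comp y x h3) (comp z x h4) h5)
}.

Arguments ceq {n} C x y : rename.
Arguments dim {n} C x : rename.
Arguments src {n} C x : rename.
Arguments tgt {n} C x : rename.
Arguments idc {n} C x : rename.
Arguments comp {n} C x y _ : rename.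

Record PreFun {n : nbar} (C D : PreCat n) : Type := {
  fmap :> cell n C -> cell n D;
  fmap_ceq : forall x y, ceq C x y -> ceq D (fmap x) (fmap y);
  fmap_dim : forall x, dim D (fmap x) = dim C x;
  fmap_src : forall x, 1 <= dim C x -> ceq D (fmap (src C x)) (src D (fmap x));
  fmap_tgt : forall x, 1 <= dim C x -> ceq D (fmap (tgt C x)) (tgt D (fmap x));
  fmap_idc : forall x, leN (S (dim C x)) n ->
      ceq D (fmap (idc C x)) (idc D (fmap x));
  fmap_comp : forall x y h h',
      ceq D (fmap (comp C x y h)) (comp D (fmap x) (fmap y) h')
}.

(* monomorphisms in PCat_n (prefunctors are equal when pointwise equal) *)
Definition precat_mono {n : nbar} {C D : PreCat n} (F : PreFun C D) : Prop :=
  forall (E : PreCat n) (G H : PreFun E C),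
    (forall x, ceq D (F (G x)) (F (H x))) -> forall x, ceq C (G x) (H x).

Inductive tm (X : Type) : Type :=
| tgen : X -> tm X
| tid : tm X -> tm X
| tsrc : tm X -> tm X
| ttgt : tm X -> tm X
| tcomp : tm X -> tm X -> tm X.
Arguments tgen {X} _.
Arguments tid {X} _.
Arguments tsrc {X} _.
Arguments ttgt {X} _.
Arguments tcomp {X} _ _.

Fixpoint tmap {X Y : Type} (f : X -> Y) (t : tm X) : tm Y :=
  match t with
  | tgen x => tgen (f x)
  | tid a => tid (tmap f a)
  | tsrc a => tsrc (tmap f a)
  | ttgt a => ttgt (tmap f a)
  | tcomp a b => tcomp (tmap f a) (tmap f b)
  end.

Fixpoint tm_below {X : Type} (d : X -> nat) (k : nat) (t : tm X) : Prop :=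
  match t with
  | tgen x => d x <= k
  | tid a | tsrc a | ttgt a => tm_below d k a
  | tcomp a b => tm_below d k a /\ tm_below d k b
  end.

Lemma tmap_iter_src {X Y} (f : X -> Y) m t :
  tmap f (Nat.iter m (@tsrc X) t) = Nat.iter m (@tsrc Y) (tmap f t).
Proof. induction m; simpl; [reflexivity | now rewrite IHm]. Qed.

Lemma tmap_iter_tgt {X Y} (f : X -> Y) m t :
  tmap f (Nat.iter m (@ttgt X) t) = Nat.iter m (@ttgt Y) (tmap f t).
Proof. induction m; simpl; [reflexivity | now rewrite IHm]. Qed.

(* The free n-precategory on generators X of dimensions d, with source
   and target terms gs, gt: [eqv k t u] means that t and u are
   well-formed k-cells of the free n-precategory and are equal there.
   It is the least such relation closed under the axioms of
   n-precategories (well-formedness of t is [eqv k t t]).  A generator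
   is a cell only once its boundary is well formed and globular. *)
Section FreeRel.
Variables (n : nbar) (X : Type) (d : X -> nat) (gs gt : X -> tm X).

Inductive eqv : nat -> tm X -> tm X -> Prop :=
| e_gen0 : forall x, d x = 0 -> eqv 0 (tgen x) (tgen x)
| e_genS : forall x k, d x = S k ->
    eqv k (gs x) (gs x) -> eqv k (gt x) (gt x) ->
    (forall k', k = S k' ->
        eqv k' (tsrc (gs x)) (tsrc (gt x)) /\ eqv k' (ttgt (gs x)) (ttgt (gt x))) ->
    eqv (S k) (tgen x) (tgen x)
| e_id : forall k t t', leN (S k) n -> eqv k t t' -> eqv (S k) (tid t) (tid t')
| e_src : forall k t t', eqv (S k) t t' -> eqv k (tsrc t) (tsrc t')
| e_tgt : forall k t t', eqv (S k) t t' -> eqv k (ttgt t) (ttgt t')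
| e_comp : forall k l t t' u u', eqv k t t' -> eqv l u u' -> 1 <= k -> 1 <= l ->
    eqv (Nat.min k l - 1)
        (Nat.iter (k - (Nat.min k l - 1)) (@ttgt X) t)
        (Nat.iter (l - (Nat.min k l - 1)) (@tsrc X) u) ->
    eqv (Nat.max k l) (tcomp t u) (tcomp t' u')
| e_sym : forall k t u, eqv k t u -> eqv k u t
| e_trans : forall k t u v, eqv k t u -> eqv k u v -> eqv k t v
| e_src_gen : forall x k, d x = S k -> eqv (S k) (tgen x) (tgen x) ->
    eqv k (tsrc (tgen x)) (gs x)
| e_tgt_gen : forall x k, d x = S k -> eqv (S k) (tgen x) (tgen x) ->
    eqv k (ttgt (tgen x)) (gt x)
| e_src_id : forall k t, leN (S k) n -> eqv k t t -> eqv k (tsrc (tid t)) t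
| e_tgt_id : forall k t, leN (S k) n -> eqv k t t -> eqv k (ttgt (tid t)) t
| e_glob_ss : forall k t, eqv (S (S k)) t t -> eqv k (tsrc (tsrc t)) (tsrc (ttgt t))
| e_glob_tt : forall k t, eqv (S (S k)) t t -> eqv k (ttgt (tsrc t)) (ttgt (ttgt t))
| e_src_ceq : forall k t u, eqv (S k) t t -> eqv (S k) u u ->
    eqv (S k) (tcomp t u) (tcomp t u) -> eqv k (tsrc (tcomp t u)) (tsrc t)
| e_tgt_ceq : forall k t u, eqv (S k) t t -> eqv (S k) u u ->
    eqv (S k) (tcomp t u) (tcomp t u) -> eqv k (ttgt (tcomp t u)) (ttgt u)
| e_src_clt : forall k l t u, eqv k t t -> eqv (S l) u u -> k < S l ->
    eqv (S l) (tcomp t u) (tcomp t u) -> eqv l (tcomp t (tsrc u)) (tcomp t (tsrc u)) ->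
    eqv l (tsrc (tcomp t u)) (tcomp t (tsrc u))
| e_tgt_clt : forall k l t u, eqv k t t -> eqv (S l) u u -> k < S l ->
    eqv (S l) (tcomp t u) (tcomp t u) -> eqv l (tcomp t (ttgt u)) (tcomp t (ttgt u)) ->
    eqv l (ttgt (tcomp t u)) (tcomp t (ttgt u))
| e_src_cgt : forall k l t u, eqv (S k) t t -> eqv l u u -> l < S k ->
    eqv (S k) (tcomp t u) (tcomp t u) -> eqv k (tcomp (tsrc t) u) (tcomp (tsrc t) u) ->
    eqv k (tsrc (tcomp t u)) (tcomp (tsrc t) u)
| e_tgt_cgt : forall k l t u, eqv (S k) t t -> eqv l u u -> l < S k ->
    eqv (S k) (tcomp t u) (tcomp t u) -> eqv k (tcomp (ttgt t) u) (tcomp (ttgt t) u) ->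
    eqv k (ttgt (tcomp t u)) (tcomp (ttgt t) u)
| e_unit_l : forall k i u, eqv k u u -> i < k ->
    eqv k (tcomp (tid (Nat.iter (k - i) (@tsrc X) u)) u)
          (tcomp (tid (Nat.iter (k - i) (@tsrc X) u)) u) ->
    eqv k (tcomp (tid (Nat.iter (k - i) (@tsrc X) u)) u) u
| e_unit_r : forall k i u, eqv k u u -> i < k ->
    eqv k (tcomp u (tid (Nat.iter (k - i) (@ttgt X) u)))
          (tcomp u (tid (Nat.iter (k - i) (@ttgt X) u))) ->
    eqv k (tcomp u (tid (Nat.iter (k - i) (@ttgt X) u))) u
| e_idc_l : forall k l t u, eqv k t t -> eqv l u u -> l <= k -> leN (S k) n ->
    eqv k (tcomp t u) (tcomp t u) -> eqv (S k) (tcomp (tid t) u) (tcomp (tid t) u) ->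
    eqv (S k) (tid (tcomp t u)) (tcomp (tid t) u)
| e_idc_r : forall k l t u, eqv k t t -> eqv l u u -> k <= l -> leN (S l) n ->
    eqv l (tcomp t u) (tcomp t u) -> eqv (S l) (tcomp t (tid u)) (tcomp t (tid u)) ->
    eqv (S l) (tid (tcomp t u)) (tcomp t (tid u))
| e_assoc : forall a b c m t u v, eqv a t t -> eqv b u u -> eqv c v v ->
    Nat.min a b = Nat.min b c ->
    Nat.min (Nat.max a b) c = Nat.min a b ->
    Nat.min a (Nat.max b c) = Nat.min a b ->
    eqv m (tcomp (tcomp t u) v) (tcomp (tcomp t u) v) ->
    eqv m (tcomp t (tcomp u v)) (tcomp t (tcomp u v)) ->
    eqv m (tcomp (tcomp t u) v) (tcomp t (tcomp u v))
| e_distr_l : forall a b c m t u v, eqv a t t -> eqv b u u -> eqv c v v ->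
    a < Nat.min b c ->
    eqv m (tcomp t (tcomp u v)) (tcomp t (tcomp u v)) ->
    eqv m (tcomp (tcomp t u) (tcomp t v)) (tcomp (tcomp t u) (tcomp t v)) ->
    eqv m (tcomp t (tcomp u v)) (tcomp (tcomp t u) (tcomp t v))
| e_distr_r : forall a b c m t u v, eqv a t t -> eqv b u u -> eqv c v v ->
    a < Nat.min b c ->
    eqv m (tcomp (tcomp u v) t) (tcomp (tcomp u v) t) ->
    eqv m (tcomp (tcomp u t) (tcomp v t)) (tcomp (tcomp u t) (tcomp v t)) ->
    eqv m (tcomp (tcomp u v) t) (tcomp (tcomp u t) (tcomp v t)).
End FreeRel.

(* n-polygraphs: generators graded by dimension (P_k = {x | gdim x = k}),
   with source and target of a (k+1)-generator given by k-cells of the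
   free n-precategory on the generators of dimension <= k, satisfying
   the globular identities. *)
Record Pol (n : nbar) : Type := {
  gen : Type;
  gdim : gen -> nat;
  gsrc : gen -> tm gen;
  gtgt : gen -> tm gen;
  gdim_le : forall x, leN (gdim x) n;
  gbelow : forall x k, gdim x = S k ->
      tm_below gdim k (gsrc x) /\ tm_below gdim k (gtgt x);
  gwf : forall x k, gdim x = S k ->
      eqv n gen gdim gsrc gtgt k (gsrc x) (gsrc x) /\
      eqv n gen gdim gsrc gtgt k (gtgt x) (gtgt x);
  gglob : forall x k, gdim x = S (S k) ->
      eqv n gen gdim gsrc gtgt k (tsrc (gsrc x)) (tsrc (gtgt x)) /\
      eqv n gen gdim gsrc gtgt k (ttgt (gsrc x)) (ttgt (gtgt x))
}.
Arguments gen {n} P : rename.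
Arguments gdim {n} P x : rename.
Arguments gsrc {n} P x : rename.
Arguments gtgt {n} P x : rename.

Definition peqv {n : nbar} (P : Pol n) : nat -> tm (gen P) -> tm (gen P) -> Prop :=
  eqv n (gen P) (gdim P) (gsrc P) (gtgt P).

Lemma gen_wf {n} (P : Pol n) x : peqv P (gdim P x) (tgen x) (tgen x).
Proof.
  unfold peqv. destruct (gdim P x) as [|k] eqn:E.
  - now apply e_gen0.
  - destruct (@gwf n P x k E) as [H1 H2].
    apply e_genS; auto. intros k' ->. apply (@gglob n P x k' E).
Qed.

Record PolMor {n : nbar} (P Q : Pol n) : Type := {
  pmap :> gen P -> gen Q;
  pmap_dim : forall x, gdim Q (pmap x) = gdim P x;
  pmap_src : forall x k, gdim P x = S k ->
      peqv Q k (tmap pmap (gsrc P x)) (gsrc Q (pmap x));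
  pmap_tgt : forall x k, gdim P x = S k ->
      peqv Q k (tmap pmap (gtgt P x)) (gtgt Q (pmap x))
}.

Definition pol_mono {n : nbar} {P Q : Pol n} (F : PolMor P Q) : Prop :=
  forall (R : Pol n) (G H : PolMor R P),
    (forall x, F (G x) = F (H x)) -> forall x, G x = H x.

Definition gens_injective {n : nbar} {P Q : Pol n} (F : PolMor P Q) : Prop :=
  forall k, leN k n -> forall x y : gen P,
    gdim P x = k -> gdim P y = k -> F x = F y -> x = y.

Section Pstar.
Context {n : nbar} (P : Pol n).
Notation X := (gen P).
Notation E := (peqv P).

Definition pcell : Type := {p : nat * tm X | E (fst p) (snd p) (snd p) /\ leN (fst p) n}.
Definition cdim (x : pcell) : nat := fst (proj1_sig x).
Definition ctm (x : pcell) : tm X := snd (proj1_sig x).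
Definition pceq (x y : pcell) : Prop := cdim x = cdim y /\ E (cdim x) (ctm x) (ctm y).

Lemma cwf (x : pcell) : E (cdim x) (ctm x) (ctm x).
Proof. exact (proj1 (proj2_sig x)). Qed.
Lemma cle (x : pcell) : leN (cdim x) n.
Proof. exact (proj2 (proj2_sig x)). Qed.

Definition src_raw (p : nat * tm X) : nat * tm X :=
  match fst p with 0 => p | S k => (k, tsrc (snd p)) end.
Definition tgt_raw (p : nat * tm X) : nat * tm X :=
  match fst p with 0 => p | S k => (k, ttgt (snd p)) end.
Definition id_raw (p : nat * tm X) : nat * tm X :=
  if leNb (S (fst p)) n then (S (fst p), tid (snd p)) else p.

Lemma src_raw_ok p : E (fst p) (snd p) (snd p) /\ leN (fst p) n ->
  E (fst (src_raw p)) (snd (src_raw p)) (snd (src_raw p)) /\ leN (fst (src_raw p)) n.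
Proof.
  destruct p as [[|k] t]; simpl; auto. intros [H1 H2]; split.
  - now apply e_src. - apply (leN_le k (S k)); auto.
Qed.
Lemma tgt_raw_ok p : E (fst p) (snd p) (snd p) /\ leN (fst p) n ->
  E (fst (tgt_raw p)) (snd (tgt_raw p)) (snd (tgt_raw p)) /\ leN (fst (tgt_raw p)) n.
Proof.
  destruct p as [[|k] t]; simpl; auto. intros [H1 H2]; split.
  - now apply e_tgt. - apply (leN_le k (S k)); auto.
Qed.
Lemma id_raw_ok p : E (fst p) (snd p) (snd p) /\ leN (fst p) n ->
  E (fst (id_raw p)) (snd (id_raw p)) (snd (id_raw p)) /\ leN (fst (id_raw p)) n.
Proof.
  unfold id_raw. destruct (leNb (S (fst p)) n) eqn:Hb; auto.
  intros [H1 H2]; simpl; split; [apply e_id|]; auto.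
Qed.

Definition psrc (x : pcell) : pcell := exist _ (src_raw (proj1_sig x)) (src_raw_ok _ (proj2_sig x)).
Definition ptgt (x : pcell) : pcell := exist _ (tgt_raw (proj1_sig x)) (tgt_raw_ok _ (proj2_sig x)).
Definition pidc (x : pcell) : pcell := exist _ (id_raw (proj1_sig x)) (id_raw_ok _ (proj2_sig x)).

Lemma psrc_iter m x : m <= cdim x ->
  proj1_sig (Nat.iter m psrc x) = (cdim x - m, Nat.iter m (@tsrc X) (ctm x)).
Proof.
  induction m; intros Hm.
  - simpl. unfold cdim, ctm. rewrite Nat.sub_0_r. now destruct (proj1_sig x).
  - change (src_raw (proj1_sig (Nat.iter m psrc x)) = (cdim x - S m, tsrc (Nat.iter m (@tsrc X) (ctm x)))).
    rewrite IHm by lia. unfold src_raw; simpl.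
    replace (cdim x - m) with (S (cdim x - S m)) by lia. reflexivity.
Qed.
Lemma ptgt_iter m x : m <= cdim x ->
  proj1_sig (Nat.iter m ptgt x) = (cdim x - m, Nat.iter m (@ttgt X) (ctm x)).
Proof.
  induction m; intros Hm.
  - simpl. unfold cdim, ctm. rewrite Nat.sub_0_r. now destruct (proj1_sig x).
  - change (tgt_raw (proj1_sig (Nat.iter m ptgt x)) = (cdim x - S m, ttgt (Nat.iter m (@ttgt X) (ctm x)))).
    rewrite IHm by lia. unfold tgt_raw; simpl.
    replace (cdim x - m) with (S (cdim x - S m)) by lia. reflexivity.
Qed.

Lemma pcomposable_syn x y : composable pceq cdim psrc ptgt x y ->
  1 <= cdim x /\ 1 <= cdim y /\
  E (Nat.min (cdim x) (cdim y) - 1)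
    (Nat.iter (cdim x - (Nat.min (cdim x) (cdim y) - 1)) (@ttgt X) (ctm x))
    (Nat.iter (cdim y - (Nat.min (cdim x) (cdim y) - 1)) (@tsrc X) (ctm y)).
Proof.
  intros [h1 [h2 [_ h3]]]. split; [|split]; auto.
  unfold cdim at 1, ctm at 1 2 in h3.
  rewrite ptgt_iter in h3 by lia. rewrite psrc_iter in h3 by lia. simpl in h3.
  replace (cdim x - (cdim x - (Nat.min (cdim x) (cdim y) - 1))) with
    (Nat.min (cdim x) (cdim y) - 1) in h3 by lia. exact h3.
Qed.

Lemma comp_raw_ok x y (h : composable pceq cdim psrc ptgt x y) :
  E (Nat.max (cdim x) (cdim y)) (tcomp (ctm x) (ctm y)) (tcomp (ctm x) (ctm y)) /\
  leN (Nat.max (cdim x) (cdim y)) n.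
Proof.
  destruct (pcomposable_syn x y h) as [h1 [h2 h3]]. split.
  - unfold peqv in *; apply e_comp; auto; apply cwf.
  - apply leN_max; apply cle.
Qed.

Definition pcomp (x y : pcell) (h : composable pceq cdim psrc ptgt x y) : pcell :=
  exist _ (Nat.max (cdim x) (cdim y), tcomp (ctm x) (ctm y)) (comp_raw_ok x y h).


Lemma cdim_psrc x : 1 <= cdim x -> cdim (psrc x) = cdim x - 1.
Proof. unfold cdim; simpl; unfold src_raw. destruct (fst (proj1_sig x)); simpl; lia. Qed.
Lemma ctm_psrc x : 1 <= cdim x -> ctm (psrc x) = tsrc (ctm x).
Proof. unfold cdim, ctm; simpl; unfold src_raw. destruct (fst (proj1_sig x)); simpl; [lia|auto]. Qed.
Lemma cdim_ptgt x : 1 <= cdim x -> cdim (ptgt x) = cdim x - 1.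
Proof. unfold cdim; simpl; unfold tgt_raw. destruct (fst (proj1_sig x)); simpl; lia. Qed.
Lemma ctm_ptgt x : 1 <= cdim x -> ctm (ptgt x) = ttgt (ctm x).
Proof. unfold cdim, ctm; simpl; unfold tgt_raw. destruct (fst (proj1_sig x)); simpl; [lia|auto]. Qed.
Lemma cdim_pidc x : leN (S (cdim x)) n -> cdim (pidc x) = S (cdim x).
Proof. destruct x as [[k t] w]; unfold cdim, leN, pidc, id_raw; simpl. intros H; now rewrite H. Qed.
Lemma ctm_pidc x : leN (S (cdim x)) n -> ctm (pidc x) = tid (ctm x).
Proof. destruct x as [[k t] w]; unfold cdim, ctm, leN, pidc, id_raw; simpl. intros H; now rewrite H. Qed.
Lemma cdim_pcomp x y h : cdim (pcomp x y h) = Nat.max (cdim x) (cdim y).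
Proof. reflexivity. Qed.
Lemma ctm_pcomp x y h : ctm (pcomp x y h) = tcomp (ctm x) (ctm y).
Proof. reflexivity. Qed.
Lemma cdim_psrc_iter m x : m <= cdim x -> cdim (Nat.iter m psrc x) = cdim x - m.
Proof. intros H; unfold cdim at 1; now rewrite psrc_iter. Qed.
Lemma ctm_psrc_iter m x : m <= cdim x -> ctm (Nat.iter m psrc x) = Nat.iter m (@tsrc X) (ctm x).
Proof. intros H; unfold ctm at 1; now rewrite psrc_iter. Qed.
Lemma cdim_ptgt_iter m x : m <= cdim x -> cdim (Nat.iter m ptgt x) = cdim x - m.
Proof. intros H; unfold cdim at 1; now rewrite ptgt_iter. Qed.
Lemma ctm_ptgt_iter m x : m <= cdim x -> ctm (Nat.iter m ptgt x) = Nat.iter m (@ttgt X) (ctm x).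
Proof. intros H; unfold ctm at 1; now rewrite ptgt_iter. Qed.

Lemma comp_dims x y (h : composable pceq cdim psrc ptgt x y) : 1 <= cdim x /\ 1 <= cdim y.
Proof. destruct h as [? [? _]]; auto. Qed.

Ltac wfs := repeat match goal with
  | a : pcell |- _ => let H := fresh "W" in
      match goal with _ : E (cdim a) (ctm a) (ctm a) |- _ => fail 1 | _ => idtac end;
      pose proof (cwf a) as H end.

Lemma P_refl x : pceq x x. Proof. split; [reflexivity|apply cwf]. Qed.
Lemma P_sym x y : pceq x y -> pceq y x.
Proof. intros [H1 H2]; split; [auto|]. rewrite <- H1. now apply e_sym. Qed.
Lemma P_trans x y z : pceq x y -> pceq y z -> pceq x z.
Proof. intros [H1 H2] [H3 H4]; split; [congruence|]. rewrite <- H1 in H4. eapply e_trans; eauto. Qed.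

Lemma E_idx k k' t u : k = k' -> E k t u -> E k' t u.
Proof. now intros ->. Qed.

Lemma P_dim_ceq x y : pceq x y -> cdim x = cdim y.
Proof. now intros [H _]. Qed.
Lemma P_src_ceq x y : 1 <= cdim x -> pceq x y -> pceq (psrc x) (psrc y).
Proof.
  intros H [H1 H2]. split.
  - rewrite !cdim_psrc; lia.
  - rewrite cdim_psrc, !ctm_psrc by lia. apply e_src. eapply E_idx; [|exact H2]; lia.
Qed.
Lemma P_tgt_ceq x y : 1 <= cdim x -> pceq x y -> pceq (ptgt x) (ptgt y).
Proof.
  intros H [H1 H2]. split.
  - rewrite !cdim_ptgt; lia.
  - rewrite cdim_ptgt, !ctm_ptgt by lia. apply e_tgt. eapply E_idx; [|exact H2]; lia.
Qed.
Lemma P_idc_ceq x y : leN (S (cdim x)) n -> pceq x y -> pceq (pidc x) (pidc y).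
Proof.
  intros H [H1 H2]. assert (H' : leN (S (cdim y)) n) by now rewrite <- H1. split.
  - rewrite !cdim_pidc by auto; lia.
  - rewrite cdim_pidc, !ctm_pidc by auto. now apply e_id.
Qed.
Lemma P_comp_ceq x x' y y' h h' : pceq x x' -> pceq y y' -> pceq (pcomp x y h) (pcomp x' y' h').
Proof.
  intros [H1 H2] [H3 H4]. split.
  - rewrite !cdim_pcomp; lia.
  - rewrite cdim_pcomp, !ctm_pcomp. destruct (pcomposable_syn x y h) as [a [b c]].
    unfold peqv in *; apply e_comp; auto.
Qed.
Lemma P_dim_src x : 1 <= cdim x -> cdim (psrc x) = cdim x - 1.
Proof. apply cdim_psrc. Qed.
Lemma P_dim_tgt x : 1 <= cdim x -> cdim (ptgt x) = cdim x - 1.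
Proof. apply cdim_ptgt. Qed.
Lemma P_glob_ss x : 2 <= cdim x -> pceq (psrc (psrc x)) (psrc (ptgt x)).
Proof.
  intros H. pose proof (cwf x) as W.
  assert (A1 : cdim (psrc x) = cdim x - 1) by (apply cdim_psrc; lia).
  assert (A2 : cdim (ptgt x) = cdim x - 1) by (apply cdim_ptgt; lia).
  split.
  - rewrite !cdim_psrc; lia.
  - rewrite cdim_psrc, !ctm_psrc, ctm_ptgt; try lia.
    rewrite A1. replace (cdim x - 1 - 1) with (cdim x - 2) by lia. apply e_glob_ss.
    eapply E_idx; [|exact W]; lia.
Qed.
Lemma P_glob_tt x : 2 <= cdim x -> pceq (ptgt (psrc x)) (ptgt (ptgt x)).
Proof.
  intros H. pose proof (cwf x) as W.
  assert (A1 : cdim (psrc x) = cdim x - 1) by (apply cdim_psrc; lia).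
  assert (A2 : cdim (ptgt x) = cdim x - 1) by (apply cdim_ptgt; lia).
  split.
  - rewrite !cdim_ptgt; lia.
  - rewrite cdim_ptgt, !ctm_ptgt, ctm_psrc; try lia.
    rewrite A1. replace (cdim x - 1 - 1) with (cdim x - 2) by lia. apply e_glob_tt.
    eapply E_idx; [|exact W]; lia.
Qed.
Lemma P_dim_idc x : leN (S (cdim x)) n -> cdim (pidc x) = S (cdim x).
Proof. apply cdim_pidc. Qed.
Lemma P_src_idc x : leN (S (cdim x)) n -> pceq (psrc (pidc x)) x.
Proof.
  intros H. split.
  - rewrite cdim_psrc, cdim_pidc by (rewrite ?cdim_pidc; auto; lia). lia.
  - rewrite cdim_psrc, cdim_pidc, ctm_psrc, ctm_pidc by (rewrite ?cdim_pidc; auto; lia).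
    replace (S (cdim x) - 1) with (cdim x) by lia. apply e_src_id; auto. apply cwf.
Qed.
Lemma P_tgt_idc x : leN (S (cdim x)) n -> pceq (ptgt (pidc x)) x.
Proof.
  intros H. split.
  - rewrite cdim_ptgt, cdim_pidc by (rewrite ?cdim_pidc; auto; lia). lia.
  - rewrite cdim_ptgt, cdim_pidc, ctm_ptgt, ctm_pidc by (rewrite ?cdim_pidc; auto; lia).
    replace (S (cdim x) - 1) with (cdim x) by lia. apply e_tgt_id; auto. apply cwf.
Qed.
Ltac fx H := eapply E_idx; [|exact H]; lia.
Lemma cwfc x y (h : composable pceq cdim psrc ptgt x y) : E (Nat.max (cdim x) (cdim y)) (tcomp (ctm x) (ctm y)) (tcomp (ctm x) (ctm y)).
Proof. exact (cwf (pcomp x y h)). Qed.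

Lemma P_dim_comp x y h : cdim (pcomp x y h) = Nat.max (cdim x) (cdim y).
Proof. reflexivity. Qed.

Lemma P_src_comp_eq x y h : cdim x = cdim y -> pceq (psrc (pcomp x y h)) (psrc x).
Proof.
  intros Hd. destruct (comp_dims x y h) as [d1 d2].
  assert (Hm : 1 <= cdim (pcomp x y h)) by (rewrite cdim_pcomp; lia).
  split.
  - rewrite !cdim_psrc, cdim_pcomp by lia. lia.
  - rewrite cdim_psrc, !ctm_psrc, cdim_pcomp, ctm_pcomp by lia.
    apply (E_idx (cdim x - 1)); [lia|]. apply e_src_ceq.
    + fx (cwf x). + fx (cwf y). + fx (cwfc x y h).
Qed.
Lemma P_tgt_comp_eq x y h : cdim x = cdim y -> pceq (ptgt (pcomp x y h)) (ptgt y).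
Proof.
  intros Hd. destruct (comp_dims x y h) as [d1 d2].
  assert (Hm : 1 <= cdim (pcomp x y h)) by (rewrite cdim_pcomp; lia).
  split.
  - rewrite !cdim_ptgt, cdim_pcomp by lia. lia.
  - rewrite cdim_ptgt, !ctm_ptgt, cdim_pcomp, ctm_pcomp by lia.
    apply (E_idx (cdim x - 1)); [lia|]. apply e_tgt_ceq.
    + fx (cwf x). + fx (cwf y). + fx (cwfc x y h).
Qed.
Lemma P_src_comp_lt x y h h' : cdim x < cdim y ->
  pceq (psrc (pcomp x y h)) (pcomp x (psrc y) h').
Proof.
  intros Hd. destruct (comp_dims x y h) as [d1 d2].
  assert (Hm : 1 <= cdim (pcomp x y h)) by (rewrite cdim_pcomp; lia).
  pose proof (cwfc x (psrc y) h') as W. rewrite cdim_psrc, ctm_psrc in W by lia.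
  split.
  - rewrite cdim_psrc, !cdim_pcomp, cdim_psrc by lia. lia.
  - rewrite cdim_psrc, ctm_psrc, cdim_pcomp, !ctm_pcomp, ctm_psrc by lia.
    apply (E_idx (cdim y - 1)); [lia|]. apply e_src_clt with (k := cdim x).
    + apply cwf. + fx (cwf y). + lia. + fx (cwfc x y h). + fx W.
Qed.
Lemma P_tgt_comp_lt x y h h' : cdim x < cdim y ->
  pceq (ptgt (pcomp x y h)) (pcomp x (ptgt y) h').
Proof.
  intros Hd. destruct (comp_dims x y h) as [d1 d2].
  assert (Hm : 1 <= cdim (pcomp x y h)) by (rewrite cdim_pcomp; lia).
  pose proof (cwfc x (ptgt y) h') as W. rewrite cdim_ptgt, ctm_ptgt in W by lia.
  split.
  - rewrite cdim_ptgt, !cdim_pcomp, cdim_ptgt by lia. lia.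
  - rewrite cdim_ptgt, ctm_ptgt, cdim_pcomp, !ctm_pcomp, ctm_ptgt by lia.
    apply (E_idx (cdim y - 1)); [lia|]. apply e_tgt_clt with (k := cdim x).
    + apply cwf. + fx (cwf y). + lia. + fx (cwfc x y h). + fx W.
Qed.
Lemma P_src_comp_gt x y h h' : cdim y < cdim x ->
  pceq (psrc (pcomp x y h)) (pcomp (psrc x) y h').
Proof.
  intros Hd. destruct (comp_dims x y h) as [d1 d2].
  assert (Hm : 1 <= cdim (pcomp x y h)) by (rewrite cdim_pcomp; lia).
  pose proof (cwfc (psrc x) y h') as W. rewrite cdim_psrc, ctm_psrc in W by lia.
  split.
  - rewrite cdim_psrc, !cdim_pcomp, cdim_psrc by lia. lia.
  - rewrite cdim_psrc, ctm_psrc, cdim_pcomp, !ctm_pcomp, ctm_psrc by lia.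
    apply (E_idx (cdim x - 1)); [lia|]. apply e_src_cgt with (l := cdim y).
    + fx (cwf x). + apply cwf. + lia. + fx (cwfc x y h). + fx W.
Qed.
Lemma P_tgt_comp_gt x y h h' : cdim y < cdim x ->
  pceq (ptgt (pcomp x y h)) (pcomp (ptgt x) y h').
Proof.
  intros Hd. destruct (comp_dims x y h) as [d1 d2].
  assert (Hm : 1 <= cdim (pcomp x y h)) by (rewrite cdim_pcomp; lia).
  pose proof (cwfc (ptgt x) y h') as W. rewrite cdim_ptgt, ctm_ptgt in W by lia.
  split.
  - rewrite cdim_ptgt, !cdim_pcomp, cdim_ptgt by lia. lia.
  - rewrite cdim_ptgt, ctm_ptgt, cdim_pcomp, !ctm_pcomp, ctm_ptgt by lia.
    apply (E_idx (cdim x - 1)); [lia|]. apply e_tgt_cgt with (l := cdim y).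
    + fx (cwf x). + apply cwf. + lia. + fx (cwfc x y h). + fx W.
Qed.
Lemma P_unit_l x i h : i < cdim x ->
  pceq (pcomp (pidc (Nat.iter (cdim x - i) psrc x)) x h) x.
Proof.
  intros Hi.
  assert (Hz : cdim (Nat.iter (cdim x - i) psrc x) = i) by (rewrite cdim_psrc_iter; lia).
  assert (Hl : leN (S (cdim (Nat.iter (cdim x - i) psrc x))) n)
    by (rewrite Hz; apply (leN_le _ (cdim x)); [lia|apply cle]).
  pose proof (cwfc _ _ h) as W.
  rewrite cdim_pidc, ctm_pidc, Hz, ctm_psrc_iter in W by (auto; lia).
  split.
  - rewrite cdim_pcomp, cdim_pidc, Hz by auto. lia.
  - rewrite cdim_pcomp, ctm_pcomp, cdim_pidc, ctm_pidc, Hz, ctm_psrc_iter by (auto; lia).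
    apply (E_idx (cdim x)); [lia|]. apply e_unit_l; [apply cwf|lia|fx W].
Qed.
Lemma P_unit_r x i h : i < cdim x ->
  pceq (pcomp x (pidc (Nat.iter (cdim x - i) ptgt x)) h) x.
Proof.
  intros Hi.
  assert (Hz : cdim (Nat.iter (cdim x - i) ptgt x) = i) by (rewrite cdim_ptgt_iter; lia).
  assert (Hl : leN (S (cdim (Nat.iter (cdim x - i) ptgt x))) n)
    by (rewrite Hz; apply (leN_le _ (cdim x)); [lia|apply cle]).
  pose proof (cwfc _ _ h) as W.
  rewrite cdim_pidc, ctm_pidc, Hz, ctm_ptgt_iter in W by (auto; lia).
  split.
  - rewrite cdim_pcomp, cdim_pidc, Hz by auto. lia.
  - rewrite cdim_pcomp, ctm_pcomp, cdim_pidc, ctm_pidc, Hz, ctm_ptgt_iter by (auto; lia).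
    apply (E_idx (cdim x)); [lia|]. apply e_unit_r; [apply cwf|lia|fx W].
Qed.
Lemma P_idc_comp_l x y h h' : cdim y <= cdim x -> leN (S (cdim x)) n ->
  pceq (pidc (pcomp x y h)) (pcomp (pidc x) y h').
Proof.
  intros Hd Hl.
  assert (Hl' : leN (S (cdim (pcomp x y h))) n) by (rewrite cdim_pcomp; now rewrite Nat.max_l).
  pose proof (cwfc _ _ h') as W. rewrite cdim_pidc, ctm_pidc in W by auto.
  split.
  - rewrite cdim_pidc, !cdim_pcomp, cdim_pidc by auto. lia.
  - rewrite cdim_pidc, ctm_pidc, !cdim_pcomp, !ctm_pcomp, ctm_pidc by auto.
    apply (E_idx (S (cdim x))); [lia|]. apply e_idc_l with (l := cdim y); auto.
    + apply cwf. + apply cwf. + fx (cwfc x y h). + fx W.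
Qed.
Lemma P_idc_comp_r x y h h' : cdim x <= cdim y -> leN (S (cdim y)) n ->
  pceq (pidc (pcomp x y h)) (pcomp x (pidc y) h').
Proof.
  intros Hd Hl.
  assert (Hl' : leN (S (cdim (pcomp x y h))) n) by (rewrite cdim_pcomp; now rewrite Nat.max_r).
  pose proof (cwfc _ _ h') as W. rewrite cdim_pidc, ctm_pidc in W by auto.
  split.
  - rewrite cdim_pidc, !cdim_pcomp, cdim_pidc by auto. lia.
  - rewrite cdim_pidc, ctm_pidc, !cdim_pcomp, !ctm_pcomp, ctm_pidc by auto.
    apply (E_idx (S (cdim y))); [lia|]. apply e_idc_r with (k := cdim x); auto.
    + apply cwf. + apply cwf. + fx (cwfc x y h). + fx W.
Qed.
Lemma P_assoc x y z h1 h2 h3 h4 :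
  Nat.min (cdim x) (cdim y) = Nat.min (cdim y) (cdim z) ->
  Nat.min (Nat.max (cdim x) (cdim y)) (cdim z) = Nat.min (cdim x) (cdim y) ->
  Nat.min (cdim x) (Nat.max (cdim y) (cdim z)) = Nat.min (cdim x) (cdim y) ->
  pceq (pcomp (pcomp x y h1) z h2) (pcomp x (pcomp y z h3) h4).
Proof.
  intros A B C. pose proof (cwf (pcomp (pcomp x y h1) z h2)) as W1.
  pose proof (cwf (pcomp x (pcomp y z h3) h4)) as W2.
  rewrite !cdim_pcomp in W1, W2.
  split.
  - rewrite !cdim_pcomp. lia.
  - rewrite !cdim_pcomp, !ctm_pcomp. rewrite !ctm_pcomp in W1, W2.
    apply e_assoc with (a := cdim x) (b := cdim y) (c := cdim z); auto.
    all: first [exact (cwf _) | fx W1 | fx W2].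
Qed.
Lemma P_distr_l x y z h1 h2 h3 h4 h5 : cdim x < Nat.min (cdim y) (cdim z) ->
  pceq (pcomp x (pcomp y z h1) h2) (pcomp (pcomp x y h3) (pcomp x z h4) h5).
Proof.
  intros A. pose proof (cwf (pcomp x (pcomp y z h1) h2)) as W1.
  pose proof (cwf (pcomp (pcomp x y h3) (pcomp x z h4) h5)) as W2.
  repeat rewrite cdim_pcomp in W1. repeat rewrite cdim_pcomp in W2. repeat rewrite ctm_pcomp in W1. repeat rewrite ctm_pcomp in W2.
  split.
  - rewrite !cdim_pcomp. lia.
  - rewrite !cdim_pcomp, !ctm_pcomp.
    apply e_distr_l with (a := cdim x) (b := cdim y) (c := cdim z); auto.
    all: first [exact (cwf _) | fx W1 | fx W2].
Qed.
Lemma P_distr_r x y z h1 h2 h3 h4 h5 : cdim x < Nat.min (cdim y) (cdim z) ->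
  pceq (pcomp (pcomp y z h1) x h2) (pcomp (pcomp y x h3) (pcomp z x h4) h5).
Proof.
  intros A. pose proof (cwf (pcomp (pcomp y z h1) x h2)) as W1.
  pose proof (cwf (pcomp (pcomp y x h3) (pcomp z x h4) h5)) as W2.
  repeat rewrite cdim_pcomp in W1. repeat rewrite cdim_pcomp in W2. repeat rewrite ctm_pcomp in W1. repeat rewrite ctm_pcomp in W2.
  split.
  - rewrite !cdim_pcomp. lia.
  - rewrite !cdim_pcomp, !ctm_pcomp.
    apply e_distr_r with (a := cdim x) (b := cdim y) (c := cdim z); auto.
    all: first [exact (cwf _) | fx W1 | fx W2].
Qed.
Lemma P_dim_le x : leN (cdim x) n.
Proof. apply cle. Qed.

End Pstar.

Definition Pstar {n : nbar} (P : Pol n) : PreCat n := {|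
  cell := pcell P; ceq := pceq P; dim := cdim P; src := psrc P; tgt := ptgt P;
  idc := pidc P; comp := pcomp P;
  ceq_refl := P_refl P; ceq_sym := P_sym P; ceq_trans := P_trans P;
  dim_ceq := P_dim_ceq P; src_ceq := P_src_ceq P; tgt_ceq := P_tgt_ceq P;
  idc_ceq := P_idc_ceq P; comp_ceq := P_comp_ceq P; dim_le := P_dim_le P;
  dim_src := P_dim_src P; dim_tgt := P_dim_tgt P; glob_ss := P_glob_ss P;
  glob_tt := P_glob_tt P; dim_idc := P_dim_idc P; src_idc := P_src_idc P;
  tgt_idc := P_tgt_idc P; dim_comp := P_dim_comp P;
  src_comp_eq := P_src_comp_eq P; tgt_comp_eq := P_tgt_comp_eq P;
  src_comp_lt := P_src_comp_lt P; tgt_comp_lt := P_tgt_comp_lt P;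
  src_comp_gt := P_src_comp_gt P; tgt_comp_gt := P_tgt_comp_gt P;
  unit_l := P_unit_l P; unit_r := P_unit_r P;
  idc_comp_l := P_idc_comp_l P; idc_comp_r := P_idc_comp_r P;
  assoc := P_assoc P; distr_l := P_distr_l P; distr_r := P_distr_r P |}.

Section Fstar.
Context {n : nbar} {P Q : Pol n} (F : PolMor P Q).

Lemma eqv_map k t u : peqv P k t u -> peqv Q k (tmap F t) (tmap F u).
Proof.
  unfold peqv. induction 1; simpl in *;
    repeat rewrite ?tmap_iter_src, ?tmap_iter_tgt in *.
  - pose proof (gen_wf Q (F x)) as G. rewrite pmap_dim, H in G. exact G.
  - pose proof (gen_wf Q (F x)) as G. rewrite pmap_dim, H in G. exact G.
  - now apply e_id.
  - now apply e_src.
  - now apply e_tgt.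
  - now apply e_comp.
  - now apply e_sym.
  - eapply e_trans; eauto.
  - eapply e_trans; [apply e_src_gen; [rewrite pmap_dim; exact H|]|].
    + pose proof (gen_wf Q (F x)) as G. rewrite pmap_dim, H in G. exact G.
    + apply e_sym. now apply pmap_src.
  - eapply e_trans; [apply e_tgt_gen; [rewrite pmap_dim; exact H|]|].
    + pose proof (gen_wf Q (F x)) as G. rewrite pmap_dim, H in G. exact G.
    + apply e_sym. now apply pmap_tgt.
  - now apply e_src_id.
  - now apply e_tgt_id.
  - now apply e_glob_ss.
  - now apply e_glob_tt.
  - now apply e_src_ceq.
  - now apply e_tgt_ceq.
  - eapply e_src_clt; eauto.
  - eapply e_tgt_clt; eauto.
  - eapply e_src_cgt; eauto.
  - eapply e_tgt_cgt; eauto.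
  - now apply e_unit_l.
  - now apply e_unit_r.
  - eapply e_idc_l; eauto.
  - eapply e_idc_r; eauto.
  - eapply e_assoc; eauto.
  - eapply e_distr_l; eauto.
  - eapply e_distr_r; eauto.
Qed.

Definition fraw (p : nat * tm (gen P)) : nat * tm (gen Q) := (fst p, tmap F (snd p)).
Lemma fraw_ok p : peqv P (fst p) (snd p) (snd p) /\ leN (fst p) n ->
  peqv Q (fst (fraw p)) (snd (fraw p)) (snd (fraw p)) /\ leN (fst (fraw p)) n.
Proof. intros [H1 H2]; split; [apply eqv_map|]; auto. Qed.
Definition fcell (x : pcell P) : pcell Q := exist _ (fraw (proj1_sig x)) (fraw_ok _ (proj2_sig x)).

Lemma cdim_f x : cdim Q (fcell x) = cdim P x. Proof. reflexivity. Qed.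
Lemma ctm_f x : ctm Q (fcell x) = tmap F (ctm P x). Proof. reflexivity. Qed.

Lemma F_ceq x y : pceq P x y -> pceq Q (fcell x) (fcell y).
Proof. intros [H1 H2]; split; [auto|apply eqv_map; auto]. Qed.
Lemma F_dim x : cdim Q (fcell x) = cdim P x. Proof. reflexivity. Qed.
Lemma F_src x : 1 <= cdim P x -> pceq Q (fcell (psrc P x)) (psrc Q (fcell x)).
Proof.
  intros H. pose proof (cwf Q (psrc Q (fcell x))) as W. split.
  - rewrite cdim_f, !cdim_psrc by auto. reflexivity.
  - rewrite cdim_f, ctm_f, cdim_psrc, ctm_psrc by auto.
    rewrite (ctm_psrc Q (fcell x)) by auto.
    rewrite cdim_psrc, ctm_psrc in W by auto. exact W.
Qed.
Lemma F_tgt x : 1 <= cdim P x -> pceq Q (fcell (ptgt P x)) (ptgt Q (fcell x)).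
Proof.
  intros H. pose proof (cwf Q (ptgt Q (fcell x))) as W. split.
  - rewrite cdim_f, !cdim_ptgt by auto. reflexivity.
  - rewrite cdim_f, ctm_f, cdim_ptgt, ctm_ptgt by auto.
    rewrite (ctm_ptgt Q (fcell x)) by auto.
    rewrite cdim_ptgt, ctm_ptgt in W by auto. exact W.
Qed.
Lemma F_idc x : leN (S (cdim P x)) n -> pceq Q (fcell (pidc P x)) (pidc Q (fcell x)).
Proof.
  intros H. pose proof (cwf Q (pidc Q (fcell x))) as W. split.
  - rewrite cdim_f, !cdim_pidc by auto. reflexivity.
  - rewrite cdim_f, ctm_f, cdim_pidc, ctm_pidc by auto.
    rewrite (ctm_pidc Q (fcell x)) by auto.
    rewrite cdim_pidc, ctm_pidc in W by auto. exact W.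
Qed.
Lemma F_comp x y h h' : pceq Q (fcell (pcomp P x y h)) (pcomp Q (fcell x) (fcell y) h').
Proof. split; [reflexivity|]. exact (cwf Q (pcomp Q (fcell x) (fcell y) h')). Qed.

Definition Fstar : PreFun (Pstar P) (Pstar Q) :=
  @Build_PreFun n (Pstar P) (Pstar Q) fcell F_ceq F_dim F_src F_tgt F_idc F_comp.
End Fstar.

(* (ii) => (i) is immediate. For (i) => (ii), adjoin to P a second copy of a
   generator x: if F x = F y, the two morphisms into P sending the copy to x and
   to y agree after F, so x = y. For (iii) => (i), distinct generators of P
   remain distinct cells of P^*.

   The substance is that a morphism injective on generators reflects equality of
   cells of the free precategories. This gives (ii) => (iii) and, in lower
   dimensions, that x and y above have equal boundaries, so that sending the
   copy to y is a morphism. We interpret Q^* in a model whose cells are either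
   cells of P^*, or "foreign" globes determined by their boundary together with
   the number of occurrences of each generator of Q in their top dimension; the
   model satisfies the precategory axioms but no interchange law. A generator
   F p is interpreted as p, which is legitimate once the boundary of F p is known
   to be interpreted as the boundary of p: this is reflection in lower
   dimensions, so the construction proceeds by induction on a dimension cutoff. *)

From Stdlib Require Import Arith Lia Bool ClassicalEpsilon.

Lemma tmap_comp {X Y Z} (f : Y -> Z) (g : X -> Y) t : tmap f (tmap g t) = tmap (fun x => f (g x)) t.
Proof. induction t; simpl; congruence. Qed.
Lemma tmap_ext {X Y} (f g : X -> Y) t : (forall x, f x = g x) -> tmap f t = tmap g t.
Proof. intros H; induction t; simpl; congruence. Qed.
Lemma tmap_id {X} (t : tm X) : tmap (fun x => x) t = t.
Proof. induction t; simpl; congruence. Qed.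

Lemma tm_below_mono {X} (d : X -> nat) k k' t : k <= k' -> tm_below d k t -> tm_below d k' t.
Proof. intros L; induction t; simpl; intuition lia. Qed.

Fixpoint tm_maxdim {X} (d : X -> nat) (t : tm X) : nat :=
  match t with
  | tgen x => d x
  | tid a | tsrc a | ttgt a => tm_maxdim d a
  | tcomp a b => Nat.max (tm_maxdim d a) (tm_maxdim d b)
  end.
Lemma tm_below_maxdim {X} (d : X -> nat) t : tm_below d (tm_maxdim d t) t.
Proof.
  induction t; simpl; auto. split; [eapply tm_below_mono; [|exact IHt1]| eapply tm_below_mono; [|exact IHt2]]; lia.
Qed.

Fixpoint tm_dim {X} (d : X -> nat) (t : tm X) : nat :=
  match t with
  | tgen x => d x
  | tid a => S (tm_dim d a)
  | tsrc a | ttgt a => pred (tm_dim d a)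
  | tcomp a b => Nat.max (tm_dim d a) (tm_dim d b)
  end.

Section StrictMap.
Variables (n : nbar) (X Y : Type) (d : X -> nat) (gs gt : X -> tm X)
  (d' : Y -> nat) (gs' gt' : Y -> tm Y) (f : X -> Y).
Hypothesis Hd : forall x, d' (f x) = d x.
Hypothesis Hs : forall x k, d x = S k -> gs' (f x) = tmap f (gs x) /\ gt' (f x) = tmap f (gt x).

Lemma eqv_tmap_strict : forall j t u, eqv n X d gs gt j t u -> eqv n Y d' gs' gt' j (tmap f t) (tmap f u).
Proof.
  fix IH 4. intros j t u H. destruct H;
  repeat match goal with Hh : eqv n X d gs gt _ _ _ |- _ =>
     let h := fresh "IHe" in pose proof (IH _ _ _ Hh) as h; revert Hh end; intros;
  simpl in *; repeat rewrite ?tmap_iter_src, ?tmap_iter_tgt in *.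
  - apply e_gen0; now rewrite Hd.
  - destruct (Hs x k H) as [E1 E2]. apply e_genS; [now rewrite Hd| rewrite E1; auto | rewrite E2; auto|].
    intros k' ->. rewrite E1, E2. match goal with Hg : forall k0, _ -> _ /\ _ |- _ =>
      destruct (Hg k' eq_refl) as [G1 G2]; split; [exact (IH _ _ _ G1)| exact (IH _ _ _ G2)] end.
  - now apply e_id.
  - now apply e_src.
  - now apply e_tgt.
  - apply e_comp; auto.
  - now apply e_sym.
  - eapply e_trans; eauto.
  - destruct (Hs x k H) as [E1 E2]. rewrite <- E1. apply e_src_gen; auto. now rewrite Hd.
  - destruct (Hs x k H) as [E1 E2]. rewrite <- E2. apply e_tgt_gen; auto. now rewrite Hd.
  - now apply e_src_id.
  - now apply e_tgt_id.
  - now apply e_glob_ss.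
  - now apply e_glob_tt.
  - now apply e_src_ceq.
  - now apply e_tgt_ceq.
  - eapply e_src_clt; eauto.
  - eapply e_tgt_clt; eauto.
  - eapply e_src_cgt; eauto.
  - eapply e_tgt_cgt; eauto.
  - now apply e_unit_l.
  - now apply e_unit_r.
  - eapply e_idc_l; eauto.
  - eapply e_idc_r; eauto.
  - eapply e_assoc; eauto.
  - eapply e_distr_l; eauto.
  - eapply e_distr_r; eauto.
Qed.
End StrictMap.

Lemma eqv_dim_leN n X d gs gt j t u : (forall x, leN (d x) n) ->
  eqv n X d gs gt j t u -> leN j n.
Proof.
  intros Hd. induction 1; auto;
  try (rewrite <- H; now auto);
  try (apply leN_max; now auto);
  try (apply (leN_le _ (S _)); [lia|]; rewrite <- H; now auto);
  try (eapply leN_le; [|eassumption]; lia).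
Qed.

(** * A model of n-precategories extending P^* *)

Section ValueModel.
Context {n : nbar} (P : Pol n) (Y : Type).
Notation XP := (gen P).
Notation EP := (peqv P).

Definition content := Y -> nat.
Definition ceqc (m m' : content) := forall x, m x = m' x.

(* [VP j a] is the j-cell [a] of P^*; [V0 m] and [VF m s t] are foreign cells of
   dimension 0 and with faces [s], [t], where [m] counts top-dimensional
   occurrences of labels. *)
Inductive val : Type :=
| V0 (m : content)
| VF (m : content) (s t : val)
| VP (j : nat) (a : tm XP).

Fixpoint dimV v := match v with V0 _ => 0 | VF _ s t => S (Nat.max (dimV s) (dimV t)) | VP j _ => j end.
Definition cont v : content := match v with V0 m | VF m _ _ => m | VP _ _ => fun _ => 0 end.
Definition srcV v := match v with V0 m => V0 m | VF _ s _ => s | VP j a => VP (pred j) (tsrc a) end.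
Definition tgtV v := match v with V0 m => V0 m | VF _ _ t => t | VP j a => VP (pred j) (ttgt a) end.
Definition idV v := match v with VP j a => VP (S j) (tid a) | _ => VF (fun _ => 0) v v end.
Definition isP v := match v with VP _ _ => true | _ => false end.

Fixpoint compV_fuel (f : nat) (v w : val) : val :=
  match f with
  | 0 => v
  | S f =>
    match v, w with
    | VP k a, VP l b => VP (Nat.max k l) (tcomp a b)
    | _, _ =>
      match Nat.compare (dimV v) (dimV w) with
      | Eq => VF (fun x => cont v x + cont w x) (srcV v) (tgtV w)
      | Lt => VF (cont w) (compV_fuel f v (srcV w)) (compV_fuel f v (tgtV w))
      | Gt => VF (cont v) (compV_fuel f (srcV v) w) (compV_fuel f (tgtV v) w)
      end
    end
  end.
Definition compV v w := compV_fuel (S (dimV v + dimV w)) v w.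

Lemma dimV_srcV v : dimV (srcV v) <= dimV v - 1.
Proof. destruct v as [|? ? ?|[|?] ?]; simpl; lia. Qed.
Lemma dimV_tgtV v : dimV (tgtV v) <= dimV v - 1.
Proof. destruct v as [|? ? ?|[|?] ?]; simpl; lia. Qed.
Lemma dimV_idV v : dimV (idV v) = S (dimV v).
Proof. destruct v; simpl; rewrite ?Nat.max_id; reflexivity. Qed.

Lemma compV_fuel_stable f : forall f' v w, dimV v + dimV w < f -> dimV v + dimV w < f' ->
  compV_fuel f v w = compV_fuel f' v w.
Proof.
  induction f as [|f IH]; intros f' v w H1 H2; [lia|].
  destruct f' as [|f']; [lia|]. simpl.
  destruct v, w; try reflexivity;
  (match goal with |- context [Nat.compare ?a ?b] => destruct (Nat.compare_spec a b) as [E|E|E] end; [reflexivity| |];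
   f_equal; apply IH; simpl in *;
   repeat match goal with |- context [dimV (srcV ?x)] => pose proof (dimV_srcV x); generalize (dimV (srcV x)) end;
   repeat match goal with |- context [dimV (tgtV ?x)] => pose proof (dimV_tgtV x); generalize (dimV (tgtV x)) end;
   intros; simpl in *; lia).
Qed.

Definition not_both_P v w := isP v && isP w = false.

Lemma compV_PP k a l b : compV (VP k a) (VP l b) = VP (Nat.max k l) (tcomp a b).
Proof. reflexivity. Qed.

Lemma compV_eq v w : not_both_P v w -> dimV v = dimV w ->
  compV v w = VF (fun x => cont v x + cont w x) (srcV v) (tgtV w).
Proof.
  intros H E. unfold compV. simpl. rewrite E, Nat.compare_refl.
  destruct v, w; try discriminate; reflexivity.
Qed.

Lemma compV_lt v w : not_both_P v w -> dimV v < dimV w ->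
  compV v w = VF (cont w) (compV v (srcV w)) (compV v (tgtV w)).
Proof.
  intros H E. unfold compV at 1. simpl.
  assert (C : Nat.compare (dimV v) (dimV w) = Lt) by (apply Nat.compare_lt_iff; auto).
  assert (G : forall x, VF (cont w) (compV_fuel (dimV v + dimV w) v (srcV w)) (compV_fuel (dimV v + dimV w) v (tgtV w)) = x ->
     x = VF (cont w) (compV v (srcV w)) (compV v (tgtV w))).
  { intros x <-. unfold compV. pose proof (dimV_srcV v); pose proof (dimV_srcV w);
    pose proof (dimV_tgtV v); pose proof (dimV_tgtV w). f_equal; apply compV_fuel_stable; lia. }
  apply G. destruct v, w; try discriminate; rewrite C; reflexivity.
Qed.

Lemma compV_gt v w : not_both_P v w -> dimV w < dimV v ->
  compV v w = VF (cont v) (compV (srcV v) w) (compV (tgtV v) w).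
Proof.
  intros H E. unfold compV at 1. simpl.
  assert (C : Nat.compare (dimV v) (dimV w) = Gt) by (apply Nat.compare_gt_iff; auto).
  assert (G : forall x, VF (cont v) (compV_fuel (dimV v + dimV w) (srcV v) w) (compV_fuel (dimV v + dimV w) (tgtV v) w) = x ->
     x = VF (cont v) (compV (srcV v) w) (compV (tgtV v) w)).
  { intros x <-. unfold compV. pose proof (dimV_srcV v); pose proof (dimV_srcV w);
    pose proof (dimV_tgtV v); pose proof (dimV_tgtV w). f_equal; apply compV_fuel_stable; lia. }
  apply G. destruct v, w; try discriminate; rewrite C; reflexivity.
Qed.

(* As for [eqv], [eqvV j v v] says that [v] is a well-formed j-cell; for foreign
   cells this includes globularity. *)
Fixpoint eqvV (j : nat) (v w : val) {struct j} : Prop :=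
  match j with
  | 0 => match v, w with
         | VP k a, VP l b => k = 0 /\ l = 0 /\ EP 0 a b
         | V0 m, V0 m' => ceqc m m'
         | _, _ => False end
  | S j' => match v, w with
         | VP k a, VP l b => k = S j' /\ l = S j' /\ EP (S j') a b
         | VF m s t, VF m' s' t' => ceqc m m' /\ eqvV j' s s' /\ eqvV j' t t' /\
             match j' with 0 => True | S j'' => eqvV j'' (srcV s) (srcV t) /\ eqvV j'' (tgtV s) (tgtV t) end
         | _, _ => False end
  end.

Lemma eqvV_P j k a l b : eqvV j (VP k a) (VP l b) <-> k = j /\ l = j /\ EP j a b.
Proof. destruct j; simpl; tauto. Qed.

Lemma eqvV_dim j : forall v w, eqvV j v w -> dimV v = j /\ dimV w = j.
Proof.
  induction j as [|j IH]; intros [] [] H; simpl in *; try tauto; try lia.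
  destruct H as [_ [H1 [H2 _]]]. apply IH in H1. apply IH in H2. lia.
Qed.

Lemma isP_eqvV j v w : eqvV j v w -> isP v = isP w.
Proof. destruct j, v, w; simpl; tauto. Qed.

Lemma cont_eqvV j v w : eqvV j v w -> ceqc (cont v) (cont w).
Proof. destruct j, v, w; simpl; intros; try tauto; try (intro; reflexivity). Qed.

Lemma srcV_cong j v w : eqvV (S j) v w -> eqvV j (srcV v) (srcV w).
Proof.
  destruct v, w; simpl; try tauto.
  intros [E1 [E2 H]]; subst. destruct j; simpl; repeat split; auto; apply e_src; auto.
Qed.
Lemma tgtV_cong j v w : eqvV (S j) v w -> eqvV j (tgtV v) (tgtV w).
Proof.
  destruct v, w; simpl; try tauto.
  intros [E1 [E2 H]]; subst. destruct j; simpl; repeat split; auto; apply e_tgt; auto.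
Qed.

(* Proved together: symmetry of the globularity clause of a foreign cell needs
   transitivity one dimension lower. *)
Lemma eqvV_sym_trans j : (forall v w, eqvV j v w -> eqvV j w v) /\
  (forall u v w, eqvV j u v -> eqvV j v w -> eqvV j u w).
Proof.
  induction j as [j IH] using (well_founded_induction lt_wf).
  destruct j as [|j'].
  - split.
    + intros [] []; simpl; intuition; try (intro x; symmetry; auto); apply e_sym; auto.
    + intros [] [] []; simpl; intuition; try (intro x; etransitivity; eauto); eapply e_trans; eauto.
  - destruct (IH j' (Nat.lt_succ_diag_r _)) as [S1 T1].
    split.
    + intros [] []; simpl; intuition; try (intro x; symmetry; auto); try (apply e_sym; auto).
      destruct j' as [|j'']; auto.
      destruct (IH j'' ltac:(lia)) as [S2 T2].
      match goal with Hg : _ /\ _ |- _ => destruct Hg as [G1 G2] end.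
      match goal with |- eqvV _ (srcV ?s0) (srcV ?t0) /\ _ =>
      match goal with Hs : eqvV _ ?s s0, Ht : eqvV _ ?t t0 |- _ =>
      split;
      [ apply T2 with (srcV s); [apply S2, srcV_cong; auto| apply T2 with (srcV t); [auto| apply srcV_cong; auto]]
      | apply T2 with (tgtV s); [apply S2, tgtV_cong; auto| apply T2 with (tgtV t); [auto| apply tgtV_cong; auto]]]
      end end.
    + intros [] [] []; simpl; intuition; try (intro x; etransitivity; eauto); try (eapply e_trans; eauto); eapply T1; eauto.
Qed.

Lemma eqvV_sym j v w : eqvV j v w -> eqvV j w v.
Proof. apply (proj1 (eqvV_sym_trans j)). Qed.
Lemma eqvV_trans j u v w : eqvV j u v -> eqvV j v w -> eqvV j u w.
Proof. apply (proj2 (eqvV_sym_trans j)). Qed.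
Lemma eqvV_refl_l j v w : eqvV j v w -> eqvV j v v.
Proof. intros H. eapply eqvV_trans; [exact H| apply eqvV_sym; exact H]. Qed.
Lemma eqvV_refl_r j v w : eqvV j v w -> eqvV j w w.
Proof. intros H. eapply eqvV_trans; [apply eqvV_sym; exact H| exact H]. Qed.

Lemma eqvV_glob j v : eqvV (S (S j)) v v ->
  eqvV j (srcV (srcV v)) (srcV (tgtV v)) /\ eqvV j (tgtV (srcV v)) (tgtV (tgtV v)).
Proof.
  destruct v; simpl; try tauto.
  intros [E1 [_ H]]; subst. destruct j; simpl; repeat split; auto.
  all: first [apply e_glob_ss; auto | apply e_glob_tt; auto].
Qed.

Lemma iter_srcV_cong m : forall j v w, m <= j -> eqvV j v w ->
  eqvV (j - m) (Nat.iter m srcV v) (Nat.iter m srcV w).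
Proof.
  induction m as [|m IH]; intros j v w Hm H; simpl.
  - now rewrite Nat.sub_0_r.
  - replace (j - S m) with (j - m - 1) by lia. destruct (j - m) eqn:E; [lia|].
    replace (S n0 - 1) with n0 by lia. apply srcV_cong. rewrite <- E. apply IH; auto; lia.
Qed.
Lemma iter_tgtV_cong m : forall j v w, m <= j -> eqvV j v w ->
  eqvV (j - m) (Nat.iter m tgtV v) (Nat.iter m tgtV w).
Proof.
  induction m as [|m IH]; intros j v w Hm H; simpl.
  - now rewrite Nat.sub_0_r.
  - replace (j - S m) with (j - m - 1) by lia. destruct (j - m) eqn:E; [lia|].
    replace (S n0 - 1) with n0 by lia. apply tgtV_cong. rewrite <- E. apply IH; auto; lia.
Qed.

Lemma iter_srcV_glob j w m : eqvV (S j) w w -> 1 <= m -> m <= j ->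
  eqvV (j - m) (Nat.iter m srcV (srcV w)) (Nat.iter m srcV (tgtV w)).
Proof.
  intros H H1 H2. destruct m as [|m]; [lia|].
  rewrite !Nat.iter_succ_r. destruct j as [|j]; [lia|].
  replace (S j - S m) with (j - m) by lia. apply iter_srcV_cong; [lia|].
  apply eqvV_glob; auto.
Qed.
Lemma iter_tgtV_glob j w m : eqvV (S j) w w -> 1 <= m -> m <= j ->
  eqvV (j - m) (Nat.iter m tgtV (srcV w)) (Nat.iter m tgtV (tgtV w)).
Proof.
  intros H H1 H2. destruct m as [|m]; [lia|].
  rewrite !Nat.iter_succ_r. destruct j as [|j]; [lia|].
  replace (S j - S m) with (j - m) by lia. apply iter_tgtV_cong; [lia|].
  apply eqvV_glob; auto.
Qed.

Lemma idV_cong j v w : leN (S j) n -> eqvV j v w -> eqvV (S j) (idV v) (idV w).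
Proof.
  intros L H. pose proof (isP_eqvV _ _ _ H) as K.
  assert (Gen : isP v = false -> isP w = false -> eqvV (S j) (VF (fun _ => 0) v v) (VF (fun _ => 0) w w)).
  { intros _ _. simpl. split; [intro; reflexivity|]. split; [auto|]. split; [auto|].
    destruct j; [exact I|]. split; [apply srcV_cong | apply tgtV_cong]; eapply eqvV_refl_l; eauto. }
  destruct v, w; simpl in K; try discriminate; try (apply Gen; reflexivity).
  apply eqvV_P in H. destruct H as [E1 [E2 H]]; subst. apply eqvV_P. repeat split; auto. apply e_id; auto.
Qed.

Lemma srcV_idV j v : leN (S j) n -> eqvV j v v -> eqvV j (srcV (idV v)) v.
Proof.
  intros L H. destruct v; simpl; auto.
  destruct j; simpl in *; destruct H as [-> [_ H]]; repeat split; auto; apply e_src_id; auto.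
Qed.
Lemma tgtV_idV j v : leN (S j) n -> eqvV j v v -> eqvV j (tgtV (idV v)) v.
Proof.
  intros L H. destruct v; simpl; auto.
  destruct j; simpl in *; destruct H as [-> [_ H]]; repeat split; auto; apply e_tgt_id; auto.
Qed.

Lemma cont_idV v : ceqc (cont (idV v)) (fun _ => 0).
Proof. destruct v; intro; reflexivity. Qed.

Lemma iter_srcV_P m : forall j a, Nat.iter m srcV (VP j a) = VP (j - m) (Nat.iter m (@tsrc _) a).
Proof. induction m; intros; simpl; [now rewrite Nat.sub_0_r|]. rewrite IHm. simpl. f_equal. lia. Qed.
Lemma iter_tgtV_P m : forall j a, Nat.iter m tgtV (VP j a) = VP (j - m) (Nat.iter m (@ttgt _) a).
Proof. induction m; intros; simpl; [now rewrite Nat.sub_0_r|]. rewrite IHm. simpl. f_equal. lia. Qed.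

Definition composableV k l (v w : val) :=
  eqvV (Nat.min k l - 1) (Nat.iter (k - (Nat.min k l - 1)) tgtV v) (Nat.iter (l - (Nat.min k l - 1)) srcV w).

Lemma composableV_cong k l v v' w w' : eqvV k v v' -> eqvV l w w' -> composableV k l v w -> composableV k l v' w'.
Proof.
  unfold composableV. intros H1 H2 H.
  pose proof (iter_tgtV_cong (k - (Nat.min k l - 1)) k v v' ltac:(lia) H1) as A.
  pose proof (iter_srcV_cong (l - (Nat.min k l - 1)) l w w' ltac:(lia) H2) as B.
  replace (k - (k - (Nat.min k l - 1))) with (Nat.min k l - 1) in A by lia.
  replace (l - (l - (Nat.min k l - 1))) with (Nat.min k l - 1) in B by lia.
  eapply eqvV_trans; [apply eqvV_sym, A|]. eapply eqvV_trans; [exact H| exact B].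
Qed.

Lemma composableV_tgt_src k v w : composableV (S k) (S k) v w -> eqvV k (tgtV v) (srcV w).
Proof.
  unfold composableV. rewrite Nat.min_id. replace (S k - 1) with k by lia.
  replace (S k - k) with 1 by lia. simpl. auto.
Qed.

Lemma composableV_faces_r k l1 v w : 1 <= k -> k <= l1 -> eqvV (S l1) w w -> composableV k (S l1) v w ->
  composableV k l1 v (srcV w) /\ composableV k l1 v (tgtV w).
Proof.
  unfold composableV. intros H0 H1 W H. rewrite Nat.min_l in H by lia. rewrite Nat.min_l by lia.
  assert (G : eqvV (k - 1) (Nat.iter (k - (k - 1)) tgtV v) (Nat.iter (l1 - (k - 1)) srcV (srcV w))).
  { rewrite <- Nat.iter_succ_r. replace (S (l1 - (k - 1))) with (S l1 - (k - 1)) by lia. exact H. }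
  split; auto.
  eapply eqvV_trans; [exact G|].
  pose proof (iter_srcV_glob l1 w (l1 - (k - 1)) W ltac:(lia) ltac:(lia)) as X.
  replace (l1 - (l1 - (k - 1))) with (k - 1) in X by lia. exact X.
Qed.

Lemma composableV_faces_l k1 l v w : 1 <= l -> l <= k1 -> eqvV (S k1) v v -> composableV (S k1) l v w ->
  composableV k1 l (srcV v) w /\ composableV k1 l (tgtV v) w.
Proof.
  unfold composableV. intros H0 H1 W H. rewrite Nat.min_r in H by lia. rewrite Nat.min_r by lia.
  assert (G : eqvV (l - 1) (Nat.iter (k1 - (l - 1)) tgtV (tgtV v)) (Nat.iter (l - (l - 1)) srcV w)).
  { rewrite <- Nat.iter_succ_r. replace (S (k1 - (l - 1))) with (S k1 - (l - 1)) by lia. exact H. }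
  split; auto.
  eapply eqvV_trans; [|exact G].
  pose proof (iter_tgtV_glob k1 v (k1 - (l - 1)) W ltac:(lia) ltac:(lia)) as X.
  replace (k1 - (k1 - (l - 1))) with (l - 1) in X by lia. exact X.
Qed.

Ltac invert_eqvV_P := repeat match goal with
  | H : eqvV _ (VP _ _) (VP _ _) |- _ => apply eqvV_P in H; destruct H as [? [? H]]; subst
  end.

Lemma not_both_P_eqvV j l v v' w w' : eqvV j v v' -> eqvV l w w' -> not_both_P v w -> not_both_P v' w'.
Proof. unfold not_both_P. intros H1 H2. rewrite <- (isP_eqvV _ _ _ H1), <- (isP_eqvV _ _ _ H2). auto. Qed.

Lemma srcV_compV_eq k v w : eqvV (S k) v v -> eqvV (S k) w w -> eqvV (S k) (compV v w) (compV v w) ->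
  eqvV k (srcV (compV v w)) (srcV v).
Proof.
  intros Hv Hw Hc. destruct (isP v && isP w) eqn:B.
  - destruct v, w; try discriminate. rewrite compV_PP in *. invert_eqvV_P. apply eqvV_P.
    rewrite Nat.max_id in *. simpl. repeat split; auto. apply e_src_ceq; auto.
  - rewrite compV_eq in * by (auto; destruct (eqvV_dim _ _ _ Hv), (eqvV_dim _ _ _ Hw); congruence).
    simpl. apply srcV_cong; auto.
Qed.
Lemma tgtV_compV_eq k v w : eqvV (S k) v v -> eqvV (S k) w w -> eqvV (S k) (compV v w) (compV v w) ->
  eqvV k (tgtV (compV v w)) (tgtV w).
Proof.
  intros Hv Hw Hc. destruct (isP v && isP w) eqn:B.
  - destruct v, w; try discriminate. rewrite compV_PP in *. invert_eqvV_P. apply eqvV_P.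
    rewrite Nat.max_id in *. simpl. repeat split; auto. apply e_tgt_ceq; auto.
  - rewrite compV_eq in * by (auto; destruct (eqvV_dim _ _ _ Hv), (eqvV_dim _ _ _ Hw); congruence).
    simpl. apply tgtV_cong; auto.
Qed.

Lemma srcV_compV_lt k l v w : k < S l -> eqvV k v v -> eqvV (S l) w w -> eqvV (S l) (compV v w) (compV v w) ->
  eqvV l (compV v (srcV w)) (compV v (srcV w)) ->
  eqvV l (srcV (compV v w)) (compV v (srcV w)).
Proof.
  intros L Hv Hw Hc Hc'. destruct (isP v && isP w) eqn:B.
  - destruct v, w; try discriminate. cbn [srcV tgtV Nat.pred] in *. rewrite !compV_PP in *. invert_eqvV_P. apply eqvV_P.
    simpl. repeat split; auto; try lia; try (rewrite Nat.max_r in * by lia); eapply e_src_clt; eauto; rewrite Nat.max_r in * by lia; auto.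
  - rewrite (compV_lt v w) by (auto; destruct (eqvV_dim _ _ _ Hv), (eqvV_dim _ _ _ Hw); lia).
    simpl. auto.
Qed.
Lemma tgtV_compV_lt k l v w : k < S l -> eqvV k v v -> eqvV (S l) w w -> eqvV (S l) (compV v w) (compV v w) ->
  eqvV l (compV v (tgtV w)) (compV v (tgtV w)) ->
  eqvV l (tgtV (compV v w)) (compV v (tgtV w)).
Proof.
  intros L Hv Hw Hc Hc'. destruct (isP v && isP w) eqn:B.
  - destruct v, w; try discriminate. cbn [srcV tgtV Nat.pred] in *. rewrite !compV_PP in *. invert_eqvV_P. apply eqvV_P.
    simpl. repeat split; auto; try lia; try (rewrite Nat.max_r in * by lia); eapply e_tgt_clt; eauto; rewrite Nat.max_r in * by lia; auto.
  - rewrite (compV_lt v w) by (auto; destruct (eqvV_dim _ _ _ Hv), (eqvV_dim _ _ _ Hw); lia).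
    simpl. auto.
Qed.
Lemma srcV_compV_gt k l v w : l < S k -> eqvV (S k) v v -> eqvV l w w -> eqvV (S k) (compV v w) (compV v w) ->
  eqvV k (compV (srcV v) w) (compV (srcV v) w) ->
  eqvV k (srcV (compV v w)) (compV (srcV v) w).
Proof.
  intros L Hv Hw Hc Hc'. destruct (isP v && isP w) eqn:B.
  - destruct v, w; try discriminate. cbn [srcV tgtV Nat.pred] in *. rewrite !compV_PP in *. invert_eqvV_P. apply eqvV_P.
    simpl. repeat split; auto; try lia; try (rewrite Nat.max_l in * by lia); eapply e_src_cgt; eauto; rewrite Nat.max_l in * by lia; auto.
  - rewrite (compV_gt v w) by (auto; destruct (eqvV_dim _ _ _ Hv), (eqvV_dim _ _ _ Hw); lia).
    simpl. auto.
Qed.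
Lemma tgtV_compV_gt k l v w : l < S k -> eqvV (S k) v v -> eqvV l w w -> eqvV (S k) (compV v w) (compV v w) ->
  eqvV k (compV (tgtV v) w) (compV (tgtV v) w) ->
  eqvV k (tgtV (compV v w)) (compV (tgtV v) w).
Proof.
  intros L Hv Hw Hc Hc'. destruct (isP v && isP w) eqn:B.
  - destruct v, w; try discriminate. cbn [srcV tgtV Nat.pred] in *. rewrite !compV_PP in *. invert_eqvV_P. apply eqvV_P.
    simpl. repeat split; auto; try lia; try (rewrite Nat.max_l in * by lia); eapply e_tgt_cgt; eauto; rewrite Nat.max_l in * by lia; auto.
  - rewrite (compV_gt v w) by (auto; destruct (eqvV_dim _ _ _ Hv), (eqvV_dim _ _ _ Hw); lia).
    simpl. auto.
Qed.

Lemma eqvV_VF_intro j m m' s s' t t' : ceqc m m' -> eqvV j s s' -> eqvV j t t' ->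
  (forall j', j = S j' -> eqvV j' (srcV s) (srcV t) /\ eqvV j' (tgtV s) (tgtV t)) ->
  eqvV (S j) (VF m s t) (VF m' s' t').
Proof. intros H1 H2 H3 H4. simpl. repeat split; auto. destruct j; auto. Qed.

Lemma eqvV_VF_elim j m m' s s' t t' : eqvV (S j) (VF m s t) (VF m' s' t') ->
  ceqc m m' /\ eqvV j s s' /\ eqvV j t t' /\
  (forall j', j = S j' -> eqvV j' (srcV s) (srcV t) /\ eqvV j' (tgtV s) (tgtV t)).
Proof. intros H. simpl in H. destruct H as [H1 [H2 [H3 H4]]]. split; [auto|]. split; [auto|]. split; [auto|]. intros jj ->. exact H4. Qed.

Lemma compV_cong_P k l v v' w w' : isP v && isP w = true -> 1 <= k -> 1 <= l ->
  eqvV k v v' -> eqvV l w w' -> composableV k l v w ->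
  eqvV (Nat.max k l) (compV v w) (compV v' w').
Proof.
  intros B Hk Hl Hv Hw Hc.
  destruct v as [| | kv a]; try discriminate. destruct w as [| | kw b]; try discriminate.
  destruct v' as [| | kv' a']; try (destruct k; simpl in Hv; tauto).
  destruct w' as [| | kw' b']; try (destruct l; simpl in Hw; tauto).
  rewrite !compV_PP. apply eqvV_P in Hv as [? [? Hv]]. apply eqvV_P in Hw as [? [? Hw]]. subst.
  unfold composableV in Hc. rewrite iter_tgtV_P, iter_srcV_P in Hc. apply eqvV_P in Hc.
  apply eqvV_P. repeat split. apply e_comp; tauto.
Qed.

Lemma compV_cong_eq k v v' w w' : not_both_P v w -> 1 <= k ->
  eqvV k v v' -> eqvV k w w' -> composableV k k v w ->
  eqvV k (compV v w) (compV v' w').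
Proof.
  intros B Hk Hv Hw Hc. destruct k as [|k1]; [lia|].
  pose proof (eqvV_refl_l _ _ _ Hv) as Wv. pose proof (eqvV_refl_l _ _ _ Hw) as Ww.
  destruct (eqvV_dim _ _ _ Hv) as [Dv Dv']. destruct (eqvV_dim _ _ _ Hw) as [Dw Dw'].
  rewrite (compV_eq v w), (compV_eq v' w') by (try eapply not_both_P_eqvV; eauto; congruence).
  apply eqvV_VF_intro.
  - intro x. rewrite (cont_eqvV _ _ _ Hv x), (cont_eqvV _ _ _ Hw x). reflexivity.
  - apply srcV_cong; auto.
  - apply tgtV_cong; auto.
  - intros k2 ->. apply composableV_tgt_src in Hc.
    destruct (eqvV_glob _ _ Wv) as [Gv1 Gv2]. destruct (eqvV_glob _ _ Ww) as [Gw1 Gw2].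
    split.
    + eapply eqvV_trans; [exact Gv1|]. eapply eqvV_trans; [apply srcV_cong, Hc| exact Gw1].
    + eapply eqvV_trans; [exact Gv2|]. eapply eqvV_trans; [apply tgtV_cong, Hc| exact Gw2].
Qed.

Section CompVCongruence.
Variable N : nat.
Hypothesis IH : forall k l v v' w w', k + l <= N -> 1 <= k -> 1 <= l ->
  eqvV k v v' -> eqvV l w w' -> composableV k l v w ->
  eqvV (Nat.max k l) (compV v w) (compV v' w').

Lemma compV_glob_lt k l2 v w : k + S (S l2) <= S N -> 1 <= k -> k <= S l2 ->
  eqvV k v v -> eqvV (S (S l2)) w w -> composableV k (S (S l2)) v w ->
  eqvV l2 (srcV (compV v (srcV w))) (srcV (compV v (tgtV w))) /\
  eqvV l2 (tgtV (compV v (srcV w))) (tgtV (compV v (tgtV w))).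
Proof.
  intros HN Hk L Wv Ww Hc.
  pose proof (srcV_cong _ _ _ Ww) as Wsw. pose proof (tgtV_cong _ _ _ Ww) as Wtw.
  destruct (composableV_faces_r k (S l2) v w) as [C1 C2]; auto; try lia.
  assert (W1 := IH k (S l2) v v (srcV w) _ ltac:(lia) Hk ltac:(lia) Wv Wsw C1).
  assert (W2 := IH k (S l2) v v (tgtV w) _ ltac:(lia) Hk ltac:(lia) Wv Wtw C2).
  rewrite Nat.max_r in W1, W2 by lia.
  destruct (eqvV_glob _ _ Ww) as [Gw1 Gw2].
  destruct (Nat.eq_dec k (S l2)) as [Ek|Ek].
  - subst k.
    pose proof (srcV_compV_eq l2 v (srcV w) Wv Wsw W1) as A1.
    pose proof (srcV_compV_eq l2 v (tgtV w) Wv Wtw W2) as A2.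
    pose proof (tgtV_compV_eq l2 v (srcV w) Wv Wsw W1) as B1.
    pose proof (tgtV_compV_eq l2 v (tgtV w) Wv Wtw W2) as B2.
    split.
    + eapply eqvV_trans; [exact A1| apply eqvV_sym; exact A2].
    + eapply eqvV_trans; [exact B1|]. eapply eqvV_trans; [exact Gw2| apply eqvV_sym; exact B2].
  - destruct (composableV_faces_r k l2 v (srcV w)) as [C11 C12]; auto; try lia.
    destruct (composableV_faces_r k l2 v (tgtV w)) as [C21 C22]; auto; try lia.
    assert (W11 := IH k l2 v v _ _ ltac:(lia) Hk ltac:(lia) Wv (srcV_cong _ _ _ Wsw) C11).
    assert (W12 := IH k l2 v v _ _ ltac:(lia) Hk ltac:(lia) Wv (tgtV_cong _ _ _ Wsw) C12).
    assert (W21 := IH k l2 v v _ _ ltac:(lia) Hk ltac:(lia) Wv (srcV_cong _ _ _ Wtw) C21).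
    assert (W22 := IH k l2 v v _ _ ltac:(lia) Hk ltac:(lia) Wv (tgtV_cong _ _ _ Wtw) C22).
    pose proof (IH k l2 v v _ _ ltac:(lia) Hk ltac:(lia) Wv Gw1 C11) as A3.
    pose proof (IH k l2 v v _ _ ltac:(lia) Hk ltac:(lia) Wv Gw2 C12) as B3.
    rewrite Nat.max_r in W11, W12, W21, W22, A3, B3 by lia.
    pose proof (srcV_compV_lt k l2 v (srcV w) ltac:(lia) Wv Wsw W1 W11) as A1.
    pose proof (srcV_compV_lt k l2 v (tgtV w) ltac:(lia) Wv Wtw W2 W21) as A2.
    pose proof (tgtV_compV_lt k l2 v (srcV w) ltac:(lia) Wv Wsw W1 W12) as B1.
    pose proof (tgtV_compV_lt k l2 v (tgtV w) ltac:(lia) Wv Wtw W2 W22) as B2.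
    split.
    + eapply eqvV_trans; [exact A1|]. eapply eqvV_trans; [exact A3| apply eqvV_sym; exact A2].
    + eapply eqvV_trans; [exact B1|]. eapply eqvV_trans; [exact B3| apply eqvV_sym; exact B2].
Qed.

Lemma compV_glob_gt k2 l v w : S (S k2) + l <= S N -> 1 <= l -> l <= S k2 ->
  eqvV (S (S k2)) v v -> eqvV l w w -> composableV (S (S k2)) l v w ->
  eqvV k2 (srcV (compV (srcV v) w)) (srcV (compV (tgtV v) w)) /\
  eqvV k2 (tgtV (compV (srcV v) w)) (tgtV (compV (tgtV v) w)).
Proof.
  intros HN Hl L Wv Ww Hc.
  pose proof (srcV_cong _ _ _ Wv) as Wsv. pose proof (tgtV_cong _ _ _ Wv) as Wtv.
  destruct (composableV_faces_l (S k2) l v w) as [C1 C2]; auto; try lia.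
  assert (W1 := IH (S k2) l (srcV v) _ w w ltac:(lia) ltac:(lia) Hl Wsv Ww C1).
  assert (W2 := IH (S k2) l (tgtV v) _ w w ltac:(lia) ltac:(lia) Hl Wtv Ww C2).
  rewrite Nat.max_l in W1, W2 by lia.
  destruct (eqvV_glob _ _ Wv) as [Gv1 Gv2].
  destruct (Nat.eq_dec l (S k2)) as [El|El].
  - subst l.
    pose proof (srcV_compV_eq k2 (srcV v) w Wsv Ww W1) as A1.
    pose proof (srcV_compV_eq k2 (tgtV v) w Wtv Ww W2) as A2.
    pose proof (tgtV_compV_eq k2 (srcV v) w Wsv Ww W1) as B1.
    pose proof (tgtV_compV_eq k2 (tgtV v) w Wtv Ww W2) as B2.
    split.
    + eapply eqvV_trans; [exact A1|]. eapply eqvV_trans; [exact Gv1| apply eqvV_sym; exact A2].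
    + eapply eqvV_trans; [exact B1| apply eqvV_sym; exact B2].
  - destruct (composableV_faces_l k2 l (srcV v) w) as [C11 C12]; auto; try lia.
    destruct (composableV_faces_l k2 l (tgtV v) w) as [C21 C22]; auto; try lia.
    assert (W11 := IH k2 l _ _ w w ltac:(lia) ltac:(lia) Hl (srcV_cong _ _ _ Wsv) Ww C11).
    assert (W12 := IH k2 l _ _ w w ltac:(lia) ltac:(lia) Hl (tgtV_cong _ _ _ Wsv) Ww C12).
    assert (W21 := IH k2 l _ _ w w ltac:(lia) ltac:(lia) Hl (srcV_cong _ _ _ Wtv) Ww C21).
    assert (W22 := IH k2 l _ _ w w ltac:(lia) ltac:(lia) Hl (tgtV_cong _ _ _ Wtv) Ww C22).
    pose proof (IH k2 l _ _ w w ltac:(lia) ltac:(lia) Hl Gv1 Ww C11) as A3.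
    pose proof (IH k2 l _ _ w w ltac:(lia) ltac:(lia) Hl Gv2 Ww C12) as B3.
    rewrite Nat.max_l in W11, W12, W21, W22, A3, B3 by lia.
    pose proof (srcV_compV_gt k2 l (srcV v) w ltac:(lia) Wsv Ww W1 W11) as A1.
    pose proof (srcV_compV_gt k2 l (tgtV v) w ltac:(lia) Wtv Ww W2 W21) as A2.
    pose proof (tgtV_compV_gt k2 l (srcV v) w ltac:(lia) Wsv Ww W1 W12) as B1.
    pose proof (tgtV_compV_gt k2 l (tgtV v) w ltac:(lia) Wtv Ww W2 W22) as B2.
    split.
    + eapply eqvV_trans; [exact A1|]. eapply eqvV_trans; [exact A3| apply eqvV_sym; exact A2].
    + eapply eqvV_trans; [exact B1|]. eapply eqvV_trans; [exact B3| apply eqvV_sym; exact B2].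
Qed.

Lemma compV_cong_lt k l1 v v' w w' : k + S l1 <= S N -> 1 <= k -> k <= l1 ->
  not_both_P v w -> eqvV k v v' -> eqvV (S l1) w w' -> composableV k (S l1) v w ->
  eqvV (S l1) (compV v w) (compV v' w').
Proof.
  intros HN Hk L B Hv Hw Hc.
  pose proof (eqvV_refl_l _ _ _ Hv) as Wv. pose proof (eqvV_refl_l _ _ _ Hw) as Ww.
  destruct (eqvV_dim _ _ _ Hv) as [Dv Dv']. destruct (eqvV_dim _ _ _ Hw) as [Dw Dw'].
  rewrite (compV_lt v w), (compV_lt v' w') by (try eapply not_both_P_eqvV; eauto; lia).
  destruct (composableV_faces_r k l1 v w) as [C1 C2]; auto; try lia.
  apply eqvV_VF_intro.
  - exact (cont_eqvV _ _ _ Hw).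
  - pose proof (IH k l1 v v' (srcV w) (srcV w') ltac:(lia) Hk ltac:(lia) Hv (srcV_cong _ _ _ Hw) C1) as X.
    rewrite Nat.max_r in X by lia. exact X.
  - pose proof (IH k l1 v v' (tgtV w) (tgtV w') ltac:(lia) Hk ltac:(lia) Hv (tgtV_cong _ _ _ Hw) C2) as X.
    rewrite Nat.max_r in X by lia. exact X.
  - intros l2 ->. apply (compV_glob_lt k); auto; lia.
Qed.

Lemma compV_cong_gt k1 l v v' w w' : S k1 + l <= S N -> 1 <= l -> l <= k1 ->
  not_both_P v w -> eqvV (S k1) v v' -> eqvV l w w' -> composableV (S k1) l v w ->
  eqvV (S k1) (compV v w) (compV v' w').
Proof.
  intros HN Hl L B Hv Hw Hc.
  pose proof (eqvV_refl_l _ _ _ Hv) as Wv. pose proof (eqvV_refl_l _ _ _ Hw) as Ww.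
  destruct (eqvV_dim _ _ _ Hv) as [Dv Dv']. destruct (eqvV_dim _ _ _ Hw) as [Dw Dw'].
  rewrite (compV_gt v w), (compV_gt v' w') by (try eapply not_both_P_eqvV; eauto; lia).
  destruct (composableV_faces_l k1 l v w) as [C1 C2]; auto; try lia.
  apply eqvV_VF_intro.
  - exact (cont_eqvV _ _ _ Hv).
  - pose proof (IH k1 l (srcV v) (srcV v') w w' ltac:(lia) ltac:(lia) Hl (srcV_cong _ _ _ Hv) Hw C1) as X.
    rewrite Nat.max_l in X by lia. exact X.
  - pose proof (IH k1 l (tgtV v) (tgtV v') w w' ltac:(lia) ltac:(lia) Hl (tgtV_cong _ _ _ Hv) Hw C2) as X.
    rewrite Nat.max_l in X by lia. exact X.
  - intros k2 ->. apply (compV_glob_gt k2 l); auto; lia.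
Qed.

End CompVCongruence.

Lemma compV_cong k l v v' w w' : 1 <= k -> 1 <= l ->
  eqvV k v v' -> eqvV l w w' -> composableV k l v w ->
  eqvV (Nat.max k l) (compV v w) (compV v' w').
Proof.
  revert k l v v' w w'.
  enough (G : forall N k l v v' w w', k + l <= N -> 1 <= k -> 1 <= l ->
    eqvV k v v' -> eqvV l w w' -> composableV k l v w ->
    eqvV (Nat.max k l) (compV v w) (compV v' w')) by eauto.
  induction N as [|N IH]; intros k l v v' w w' HN Hk Hl Hv Hw Hc; [lia|].
  destruct (isP v && isP w) eqn:B; [now apply compV_cong_P|].
  destruct (Nat.compare_spec k l) as [<-|E|E].
  - rewrite Nat.max_id. now apply compV_cong_eq.
  - destruct l as [|l1]; [lia|]. rewrite Nat.max_r by lia.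
    apply (compV_cong_lt N IH k); auto; lia.
  - destruct k as [|k1]; [lia|]. rewrite Nat.max_l by lia.
    apply (compV_cong_gt N IH k1 l); auto; lia.
Qed.

Lemma compV_wf k l v w : 1 <= k -> 1 <= l -> eqvV k v v -> eqvV l w w -> composableV k l v w ->
  eqvV (Nat.max k l) (compV v w) (compV v w).
Proof. intros. now apply compV_cong. Qed.

Lemma eqvV_VF_r j m m' s s' t t' : eqvV (S j) (VF m' s' t') (VF m' s' t') ->
  ceqc m m' -> eqvV j s s' -> eqvV j t t' -> eqvV (S j) (VF m s t) (VF m' s' t').
Proof.
  intros W H1 H2 H3. apply eqvV_VF_elim in W. destruct W as [_ [_ [_ G]]].
  apply eqvV_VF_intro; auto. intros j' ->. destruct (G j' eq_refl) as [G1 G2]. split.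
  - eapply eqvV_trans; [apply srcV_cong, H2|]. eapply eqvV_trans; [exact G1| apply eqvV_sym, srcV_cong, H3].
  - eapply eqvV_trans; [apply tgtV_cong, H2|]. eapply eqvV_trans; [exact G2| apply eqvV_sym, tgtV_cong, H3].
Qed.

Lemma isP_compV v w : isP (compV v w) = isP v && isP w.
Proof.
  destruct (isP v && isP w) eqn:B.
  - destruct v, w; try discriminate. reflexivity.
  - destruct (Nat.compare_spec (dimV v) (dimV w)).
    + rewrite compV_eq; auto.
    + rewrite compV_lt; auto.
    + rewrite compV_gt; auto.
Qed.

Lemma isP_idV v : isP (idV v) = isP v.
Proof. destruct v; reflexivity. Qed.

Lemma cont_compV_eq v w : dimV v = dimV w -> ceqc (cont (compV v w)) (fun x => cont v x + cont w x).
Proof.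
  intros E. destruct (isP v && isP w) eqn:B.
  - destruct v, w; try discriminate. intro; reflexivity.
  - rewrite compV_eq; auto. intro; reflexivity.
Qed.
Lemma cont_compV_lt v w : dimV v < dimV w -> ceqc (cont (compV v w)) (cont w).
Proof.
  intros E. destruct (isP v && isP w) eqn:B.
  - destruct v, w; try discriminate. intro; reflexivity.
  - rewrite compV_lt; auto. intro; reflexivity.
Qed.
Lemma cont_compV_gt v w : dimV w < dimV v -> ceqc (cont (compV v w)) (cont v).
Proof.
  intros E. destruct (isP v && isP w) eqn:B.
  - destruct v, w; try discriminate. intro; reflexivity.
  - rewrite compV_gt; auto. intro; reflexivity.
Qed.

Lemma composableV_unit_l k i u x : i < k -> leN k n -> eqvV k u u ->
  eqvV i x (Nat.iter (k - i) srcV u) -> composableV (S i) k (idV x) u.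
Proof.
  intros L N0 Wu Hx. unfold composableV. rewrite Nat.min_l by lia. replace (S i - 1) with i by lia.
  replace (S i - i) with 1 by lia. simpl. eapply eqvV_trans; [|exact Hx].
  apply tgtV_idV; [apply (leN_le _ k); auto; lia| eapply eqvV_refl_l; eauto].
Qed.
Lemma composableV_unit_r k i u x : i < k -> leN k n -> eqvV k u u ->
  eqvV i x (Nat.iter (k - i) tgtV u) -> composableV k (S i) u (idV x).
Proof.
  intros L N0 Wu Hx. unfold composableV. rewrite Nat.min_r by lia. replace (S i - 1) with i by lia.
  replace (S i - i) with 1 by lia. simpl. apply eqvV_sym. eapply eqvV_trans; [|exact Hx].
  apply srcV_idV; [apply (leN_le _ k); auto; lia| eapply eqvV_refl_l; eauto].
Qed.

Lemma compV_unit_l_P k i ku b x : i < S k -> leN (S k) n -> eqvV (S k) (VP ku b) (VP ku b) ->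
  eqvV i x (Nat.iter (S k - i) srcV (VP ku b)) -> eqvV (S k) (compV (idV x) (VP ku b)) (VP ku b).
Proof.
  intros L N0 Wu Hx.
  assert (NI : leN (S i) n) by (apply (leN_le _ (S k)); auto; lia).
  pose proof (composableV_unit_l _ _ _ _ L N0 Wu Hx) as C.
  pose proof Wu as Wu'. apply eqvV_P in Wu'. destruct Wu' as [E1 [_ Wb]]. subst ku.
  rewrite iter_srcV_P in Hx. destruct x as [| |kx a]; try (destruct i; simpl in Hx; tauto).
  apply eqvV_P in Hx. destruct Hx as [E2 [E3 Hx]]. subst kx.
  set (x0 := VP (S k - (S k - i)) (Nat.iter (S k - i) (@tsrc _) b)).
  assert (Hx0 : eqvV i (VP i a) x0) by (apply eqvV_P; repeat split; auto; lia).
  pose proof (compV_cong (S i) (S k) _ _ _ _ ltac:(lia) ltac:(lia) (idV_cong _ _ _ NI Hx0) Wu C) as C1.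
  rewrite Nat.max_r in C1 by lia. eapply eqvV_trans; [exact C1|].
  pose proof (eqvV_refl_r _ _ _ C1) as W2.
  unfold x0 in *. cbn [idV] in *. rewrite compV_PP in *.
  replace (S k - (S k - i)) with i in * by lia. rewrite Nat.max_r in * by lia.
  apply eqvV_P in W2. destruct W2 as [_ [_ W2]].
  apply eqvV_P. repeat split; auto. apply e_unit_l; auto.
Qed.

Lemma compV_unit_l k : forall u x i, eqvV k u u -> i < k -> leN k n ->
  eqvV i x (Nat.iter (k - i) srcV u) -> eqvV k (compV (idV x) u) u.
Proof.
  induction k as [|k IH]; intros u x i Wu L N0 Hx; [lia|].
  assert (NI : leN (S i) n) by (apply (leN_le _ (S k)); auto; lia).
  pose proof (eqvV_refl_l _ _ _ Hx) as Wx.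
  pose proof (composableV_unit_l _ _ _ _ L N0 Wu Hx) as C.
  pose proof (idV_cong _ _ _ NI Wx) as Wix.
  destruct u as [m|m s t|ku b].
  - simpl in Wu. tauto.
  - assert (NB : not_both_P (idV x) (VF m s t)) by (unfold not_both_P; rewrite andb_false_r; auto).
    destruct (eqvV_dim _ _ _ Wx) as [Dx _]. pose proof (eqvV_dim _ _ _ Wu) as [Du _].
    pose proof (eqvV_VF_elim _ _ _ _ _ _ _ Wu) as [_ [Ws [Wt G]]].
    destruct (Nat.eq_dec i k) as [E|E].
    + rewrite E in *. rewrite compV_eq by (auto; rewrite dimV_idV; congruence).
      replace (S k - k) with 1 in Hx by lia. simpl in Hx.
      apply eqvV_VF_r; auto.
      * intro y. rewrite (cont_idV x y). reflexivity.
      * eapply eqvV_trans; [apply srcV_idV; auto| exact Hx].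
    + rewrite compV_lt by (auto; rewrite dimV_idV, Du, Dx; lia).
      assert (Hs : eqvV i x (Nat.iter (k - i) srcV s)).
      { change (eqvV i x (Nat.iter (k - i) srcV (srcV (VF m s t)))).
        rewrite <- Nat.iter_succ_r. replace (S (k - i)) with (S k - i) by lia. exact Hx. }
      assert (Ht : eqvV i x (Nat.iter (k - i) srcV t)).
      { eapply eqvV_trans; [exact Hs|].
        pose proof (iter_srcV_glob k (VF m s t) (k - i) Wu ltac:(lia) ltac:(lia)) as X.
        replace (k - (k - i)) with i in X by lia. exact X. }
      apply eqvV_VF_r; auto.
      * intro; reflexivity.
      * apply IH with (i := i); auto; try lia. apply (leN_le _ (S k)); auto.
      * apply IH with (i := i); auto; try lia. apply (leN_le _ (S k)); auto.
  - apply (compV_unit_l_P k i); auto.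
Qed.

Lemma compV_unit_r_P k i ku b x : i < S k -> leN (S k) n -> eqvV (S k) (VP ku b) (VP ku b) ->
  eqvV i x (Nat.iter (S k - i) tgtV (VP ku b)) -> eqvV (S k) (compV (VP ku b) (idV x)) (VP ku b).
Proof.
  intros L N0 Wu Hx.
  assert (NI : leN (S i) n) by (apply (leN_le _ (S k)); auto; lia).
  pose proof (composableV_unit_r _ _ _ _ L N0 Wu Hx) as C.
  pose proof Wu as Wu'. apply eqvV_P in Wu'. destruct Wu' as [E1 [_ Wb]]. subst ku.
  rewrite iter_tgtV_P in Hx. destruct x as [| |kx a]; try (destruct i; simpl in Hx; tauto).
  apply eqvV_P in Hx. destruct Hx as [E2 [E3 Hx]]. subst kx.
  set (x0 := VP (S k - (S k - i)) (Nat.iter (S k - i) (@ttgt _) b)).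
  assert (Hx0 : eqvV i (VP i a) x0) by (apply eqvV_P; repeat split; auto; lia).
  pose proof (compV_cong (S k) (S i) _ _ _ _ ltac:(lia) ltac:(lia) Wu (idV_cong _ _ _ NI Hx0) C) as C1.
  rewrite Nat.max_l in C1 by lia. eapply eqvV_trans; [exact C1|].
  pose proof (eqvV_refl_r _ _ _ C1) as W2.
  unfold x0 in *. cbn [idV] in *. rewrite compV_PP in *.
  replace (S k - (S k - i)) with i in * by lia. rewrite Nat.max_l in * by lia.
  apply eqvV_P in W2. destruct W2 as [_ [_ W2]].
  apply eqvV_P. repeat split; auto. apply e_unit_r; auto.
Qed.

Lemma compV_unit_r k : forall u x i, eqvV k u u -> i < k -> leN k n ->
  eqvV i x (Nat.iter (k - i) tgtV u) -> eqvV k (compV u (idV x)) u.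
Proof.
  induction k as [|k IH]; intros u x i Wu L N0 Hx; [lia|].
  assert (NI : leN (S i) n) by (apply (leN_le _ (S k)); auto; lia).
  pose proof (eqvV_refl_l _ _ _ Hx) as Wx.
  pose proof (composableV_unit_r _ _ _ _ L N0 Wu Hx) as C.
  pose proof (idV_cong _ _ _ NI Wx) as Wix.
  destruct u as [m|m s t|ku b].
  - simpl in Wu. tauto.
  - assert (NB : not_both_P (VF m s t) (idV x)) by (unfold not_both_P; reflexivity).
    destruct (eqvV_dim _ _ _ Wx) as [Dx _]. pose proof (eqvV_dim _ _ _ Wu) as [Du _].
    pose proof (eqvV_VF_elim _ _ _ _ _ _ _ Wu) as [_ [Ws [Wt G]]].
    destruct (Nat.eq_dec i k) as [E|E].
    + rewrite E in *. rewrite compV_eq by (auto; rewrite dimV_idV; congruence).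
      replace (S k - k) with 1 in Hx by lia. simpl in Hx.
      apply eqvV_VF_r; auto.
      * intro y. rewrite (cont_idV x y). simpl. lia.
      * eapply eqvV_trans; [apply tgtV_idV; auto| exact Hx].
    + rewrite compV_gt by (auto; rewrite dimV_idV, Du, Dx; lia).
      assert (Ht : eqvV i x (Nat.iter (k - i) tgtV t)).
      { change (eqvV i x (Nat.iter (k - i) tgtV (tgtV (VF m s t)))). rewrite <- Nat.iter_succ_r.
        replace (S (k - i)) with (S k - i) by lia. exact Hx. }
      assert (Hs : eqvV i x (Nat.iter (k - i) tgtV s)).
      { eapply eqvV_trans; [exact Ht|].
        pose proof (iter_tgtV_glob k (VF m s t) (k - i) Wu ltac:(lia) ltac:(lia)) as X.
        replace (k - (k - i)) with i in X by lia. apply eqvV_sym. exact X. }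
      apply eqvV_VF_r; auto.
      * intro; reflexivity.
      * apply IH with (i := i); auto; try lia. apply (leN_le _ (S k)); auto.
      * apply IH with (i := i); auto; try lia. apply (leN_le _ (S k)); auto.
  - apply (compV_unit_r_P k i); auto.
Qed.

Lemma composableV_idV_l k l v w : 1 <= l -> l <= k -> leN (S k) n -> eqvV k v v ->
  composableV k l v w -> composableV (S k) l (idV v) w.
Proof.
  unfold composableV. intros H0 H1 N0 Wv H. rewrite Nat.min_r in * by lia.
  replace (S k - (l - 1)) with (S (k - (l - 1))) by lia. rewrite Nat.iter_succ_r.
  eapply eqvV_trans; [|exact H].
  pose proof (iter_tgtV_cong (k - (l - 1)) k _ _ ltac:(lia) (tgtV_idV _ _ N0 Wv)) as X.
  replace (k - (k - (l - 1))) with (l - 1) in X by lia. exact X.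
Qed.
Lemma composableV_idV_r k l v w : 1 <= k -> k <= l -> leN (S l) n -> eqvV l w w ->
  composableV k l v w -> composableV k (S l) v (idV w).
Proof.
  unfold composableV. intros H0 H1 N0 Ww H. rewrite Nat.min_l in * by lia.
  replace (S l - (k - 1)) with (S (l - (k - 1))) by lia. rewrite Nat.iter_succ_r.
  eapply eqvV_trans; [exact H|]. apply eqvV_sym.
  pose proof (iter_srcV_cong (l - (k - 1)) l _ _ ltac:(lia) (srcV_idV _ _ N0 Ww)) as X.
  replace (l - (l - (k - 1))) with (k - 1) in X by lia. exact X.
Qed.

Lemma idV_compV_l k l v w : 1 <= l -> l <= k -> leN (S k) n -> eqvV k v v -> eqvV l w w ->
  composableV k l v w -> eqvV (S k) (idV (compV v w)) (compV (idV v) w).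
Proof.
  intros H0 H1 N0 Wv Ww C.
  pose proof (compV_wf k l v w ltac:(lia) H0 Wv Ww C) as Wc. rewrite Nat.max_l in Wc by lia.
  pose proof (composableV_idV_l _ _ _ _ H0 H1 N0 Wv C) as C'.
  pose proof (idV_cong _ _ _ N0 Wv) as Wiv.
  pose proof (compV_wf (S k) l _ w ltac:(lia) H0 Wiv Ww C') as Wc'. rewrite Nat.max_l in Wc' by lia.
  destruct (eqvV_dim _ _ _ Wv) as [Dv _]. destruct (eqvV_dim _ _ _ Ww) as [Dw _].
  destruct (isP v && isP w) eqn:B.
  - destruct v as [| |kv a]; try discriminate. destruct w as [| |kw b]; try discriminate.
    cbn [idV] in *. rewrite !compV_PP in *.
    apply eqvV_P in Wv. apply eqvV_P in Ww. destruct Wv as [? [_ Wv]], Ww as [? [_ Ww]]. subst.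
    apply eqvV_P in Wc. apply eqvV_P in Wc'. destruct Wc as [_ [_ Wc]], Wc' as [_ [_ Wc']].
    apply eqvV_P. rewrite Nat.max_l in * by lia. repeat split; auto; try lia. eapply e_idc_l; eauto.
  - assert (NB : not_both_P (idV v) w) by (unfold not_both_P; rewrite isP_idV; auto).
    assert (isP (compV v w) = false) as K by (rewrite isP_compV; auto).
    rewrite (compV_gt (idV v) w) in * by (auto; rewrite dimV_idV; lia).
    destruct (compV v w) as [| |]eqn:Ec; try discriminate; cbn [idV];
    (apply eqvV_VF_r; [exact Wc'| intro y; rewrite (cont_idV v y); reflexivity| |];
     rewrite <- Ec; [pose proof (srcV_idV _ _ N0 Wv) as X | pose proof (tgtV_idV _ _ N0 Wv) as X];
     pose proof (compV_cong k l _ _ w w ltac:(lia) H0 (eqvV_sym _ _ _ X) Ww C) as Z;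
     rewrite Nat.max_l in Z by lia; exact Z).
Qed.

Lemma idV_compV_r k l v w : 1 <= k -> k <= l -> leN (S l) n -> eqvV k v v -> eqvV l w w ->
  composableV k l v w -> eqvV (S l) (idV (compV v w)) (compV v (idV w)).
Proof.
  intros H0 H1 N0 Wv Ww C.
  pose proof (compV_wf k l v w H0 ltac:(lia) Wv Ww C) as Wc. rewrite Nat.max_r in Wc by lia.
  pose proof (composableV_idV_r _ _ _ _ H0 H1 N0 Ww C) as C'.
  pose proof (idV_cong _ _ _ N0 Ww) as Wiw.
  pose proof (compV_wf k (S l) v _ H0 ltac:(lia) Wv Wiw C') as Wc'. rewrite Nat.max_r in Wc' by lia.
  destruct (eqvV_dim _ _ _ Wv) as [Dv _]. destruct (eqvV_dim _ _ _ Ww) as [Dw _].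
  destruct (isP v && isP w) eqn:B.
  - destruct v as [| |kv a]; try discriminate. destruct w as [| |kw b]; try discriminate.
    cbn [idV] in *. rewrite !compV_PP in *.
    apply eqvV_P in Wv. apply eqvV_P in Ww. destruct Wv as [? [_ Wv]], Ww as [? [_ Ww]]. subst.
    apply eqvV_P in Wc. apply eqvV_P in Wc'. destruct Wc as [_ [_ Wc]], Wc' as [_ [_ Wc']].
    apply eqvV_P. rewrite Nat.max_r in * by lia. repeat split; auto; try lia. eapply e_idc_r; eauto.
  - assert (NB : not_both_P v (idV w)) by (unfold not_both_P; rewrite isP_idV; auto).
    assert (isP (compV v w) = false) as K by (rewrite isP_compV; auto).
    rewrite (compV_lt v (idV w)) in * by (auto; rewrite dimV_idV; lia).
    destruct (compV v w) as [| |]eqn:Ec; try discriminate; cbn [idV];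
    (apply eqvV_VF_r; [exact Wc'| intro y; rewrite (cont_idV w y); reflexivity| |];
     rewrite <- Ec; [pose proof (srcV_idV _ _ N0 Ww) as X | pose proof (tgtV_idV _ _ N0 Ww) as X];
     pose proof (compV_cong k l v v _ _ H0 ltac:(lia) Wv (eqvV_sym _ _ _ X) C) as Z;
     rewrite Nat.max_r in Z by lia; exact Z).
Qed.

Ltac simpl_max := repeat match goal with
  | H : context [Nat.max ?p ?q] |- _ => first [rewrite (Nat.max_l p q) in H by lia | rewrite (Nat.max_r p q) in H by lia]
  | |- context [Nat.max ?p ?q] => first [rewrite (Nat.max_l p q) by lia | rewrite (Nat.max_r p q) by lia]
  end.

Section CompVAssoc.
Variable N : nat.
Hypothesis IH : forall a b c x y z, a + b + c <= N -> 1 <= a -> 1 <= b -> 1 <= c ->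
  eqvV a x x -> eqvV b y y -> eqvV c z z ->
  Nat.min a b = Nat.min b c -> Nat.min (Nat.max a b) c = Nat.min a b ->
  Nat.min a (Nat.max b c) = Nat.min a b ->
  composableV a b x y -> composableV b c y z -> composableV (Nat.max a b) c (compV x y) z ->
  composableV a (Nat.max b c) x (compV y z) ->
  eqvV (Nat.max (Nat.max a b) c) (compV (compV x y) z) (compV x (compV y z)).

Lemma compV_assoc_P a b c x y z : 1 <= a -> 1 <= b -> 1 <= c ->
  eqvV a x x -> eqvV b y y -> eqvV c z z ->
  Nat.min a b = Nat.min b c -> Nat.min (Nat.max a b) c = Nat.min a b ->
  Nat.min a (Nat.max b c) = Nat.min a b ->
  composableV a b x y -> composableV b c y z -> composableV (Nat.max a b) c (compV x y) z ->
  composableV a (Nat.max b c) x (compV y z) ->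
  isP x && isP y && isP z = true ->
  eqvV (Nat.max (Nat.max a b) c) (compV (compV x y) z) (compV x (compV y z)).
Proof.
  intros Ha Hb Hc Wx Wy Wz M1 M2 M3 Cxy Cyz CL CR B.
  pose proof (compV_wf a b x y Ha Hb Wx Wy Cxy) as Wxy.
  pose proof (compV_wf b c y z Hb Hc Wy Wz Cyz) as Wyz.
  pose proof (compV_wf (Nat.max a b) c _ z ltac:(lia) Hc Wxy Wz CL) as WL.
  pose proof (compV_wf a (Nat.max b c) x _ Ha ltac:(lia) Wx Wyz CR) as WR.
  rewrite <- Nat.max_assoc.
  destruct x as [| |ka ta]; try discriminate. destruct y as [| |kb tb]; try discriminate.
  destruct z as [| |kc tc]; try discriminate. rewrite !compV_PP in *.
  apply eqvV_P in Wx. apply eqvV_P in Wy. apply eqvV_P in Wz.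
  destruct Wx as [? [_ Wx]], Wy as [? [_ Wy]], Wz as [? [_ Wz]]. subst.
  apply eqvV_P in WL. apply eqvV_P in WR. destruct WL as [_ [_ WL]], WR as [_ [_ WR]].
  apply eqvV_P. rewrite Nat.max_assoc in *. repeat split; auto.
  eapply e_assoc; eauto.
Qed.

Lemma compV_assoc_eq a b c x y z : a + b + c <= S N -> 1 <= a -> 1 <= b -> 1 <= c ->
  eqvV a x x -> eqvV b y y -> eqvV c z z ->
  composableV a b x y -> composableV b c y z -> composableV (Nat.max a b) c (compV x y) z ->
  composableV a (Nat.max b c) x (compV y z) ->
  a = b -> b = c ->
  not_both_P (compV x y) z -> not_both_P x (compV y z) ->
  eqvV (Nat.max (Nat.max a b) c) (compV (compV x y) z) (compV x (compV y z)).
Proof.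
  intros HN Ha Hb Hc Wx Wy Wz Cxy Cyz CL CR E1 E2 NL NR.
  pose proof (compV_wf a b x y Ha Hb Wx Wy Cxy) as Wxy.
  pose proof (compV_wf b c y z Hb Hc Wy Wz Cyz) as Wyz.
  pose proof (compV_wf (Nat.max a b) c _ z ltac:(lia) Hc Wxy Wz CL) as WL.
  pose proof (compV_wf a (Nat.max b c) x _ Ha ltac:(lia) Wx Wyz CR) as WR.
  rewrite <- Nat.max_assoc.
  subst b c. rewrite !Nat.max_id in *. destruct (eqvV_dim _ _ _ Wx) as [Dx _]. destruct (eqvV_dim _ _ _ Wy) as [Dy _].
  destruct (eqvV_dim _ _ _ Wz) as [Dz _]. destruct (eqvV_dim _ _ _ Wxy) as [Dxy _].
  destruct (eqvV_dim _ _ _ Wyz) as [Dyz _]. destruct a as [|a1]; [lia|].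
  rewrite (compV_eq (compV x y) z) by (auto; congruence).
  rewrite (compV_eq x (compV y z)) in WR |- * by (auto; congruence).
  apply eqvV_VF_r; auto.
  * intro q. rewrite (cont_compV_eq x y ltac:(congruence) q), (cont_compV_eq y z ltac:(congruence) q). lia.
  * apply srcV_compV_eq; auto.
  * apply eqvV_sym, tgtV_compV_eq; auto.
Qed.

Lemma compV_assoc_x_high a b c x y z : a + b + c <= S N -> 1 <= a -> 1 <= b -> 1 <= c ->
  eqvV a x x -> eqvV b y y -> eqvV c z z ->
  composableV a b x y -> composableV b c y z -> composableV (Nat.max a b) c (compV x y) z ->
  composableV a (Nat.max b c) x (compV y z) ->
  b = c -> c < a ->
  not_both_P (compV x y) z -> not_both_P x (compV y z) ->
  eqvV (Nat.max (Nat.max a b) c) (compV (compV x y) z) (compV x (compV y z)).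
Proof.
  intros HN Ha Hb Hc Wx Wy Wz Cxy Cyz CL CR E1 E2 NL NR.
  pose proof (compV_wf a b x y Ha Hb Wx Wy Cxy) as Wxy.
  pose proof (compV_wf b c y z Hb Hc Wy Wz Cyz) as Wyz.
  pose proof (compV_wf (Nat.max a b) c _ z ltac:(lia) Hc Wxy Wz CL) as WL.
  pose proof (compV_wf a (Nat.max b c) x _ Ha ltac:(lia) Wx Wyz CR) as WR.
  rewrite <- Nat.max_assoc.
  subst c. destruct a as [|a1]; [lia|]. simpl_max. destruct (eqvV_dim _ _ _ Wx) as [Dx _]. destruct (eqvV_dim _ _ _ Wy) as [Dy _].
  destruct (eqvV_dim _ _ _ Wz) as [Dz _]. destruct (eqvV_dim _ _ _ Wxy) as [Dxy _].
  destruct (eqvV_dim _ _ _ Wyz) as [Dyz _].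
  rewrite (compV_gt (compV x y) z) by (auto; lia).
  rewrite (compV_gt x (compV y z)) in WR |- * by (auto; lia).
  destruct (composableV_faces_l a1 b x y) as [C1s C1t]; auto; try lia.
  destruct (composableV_faces_l a1 b (compV x y) z) as [C2s C2t]; auto; try lia.
  destruct (composableV_faces_l a1 b x (compV y z)) as [C3s C3t]; auto; try lia.
  pose proof (srcV_cong _ _ _ Wx) as Wx1. pose proof (tgtV_cong _ _ _ Wx) as Wx2.
  pose proof (compV_wf a1 b _ y ltac:(lia) Hb Wx1 Wy C1s) as W1s.
  pose proof (compV_wf a1 b _ y ltac:(lia) Hb Wx2 Wy C1t) as W1t.
  simpl_max.
  pose proof (srcV_compV_gt a1 b x y ltac:(lia) Wx Wy Wxy W1s) as SXY.
  pose proof (tgtV_compV_gt a1 b x y ltac:(lia) Wx Wy Wxy W1t) as TXY.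
  apply eqvV_VF_r; auto.
  * exact (cont_compV_gt x y ltac:(lia)).
  * eapply eqvV_trans.
    -- pose proof (compV_cong a1 b _ _ z z ltac:(lia) Hb SXY Wz C2s) as X. simpl_max. exact X.
    -- pose proof (IH a1 b b (srcV x) y z ltac:(lia) ltac:(lia) Hb Hb Wx1 Wy Wz) as X.
       simpl_max. apply X; auto; try lia.
       eapply composableV_cong; [exact SXY| exact Wz| exact C2s].
  * eapply eqvV_trans.
    -- pose proof (compV_cong a1 b _ _ z z ltac:(lia) Hb TXY Wz C2t) as X. simpl_max. exact X.
    -- pose proof (IH a1 b b (tgtV x) y z ltac:(lia) ltac:(lia) Hb Hb Wx2 Wy Wz) as X.
       simpl_max. apply X; auto; try lia.
       eapply composableV_cong; [exact TXY| exact Wz| exact C2t].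
Qed.

Lemma compV_assoc_y_high a b c x y z : a + b + c <= S N -> 1 <= a -> 1 <= b -> 1 <= c ->
  eqvV a x x -> eqvV b y y -> eqvV c z z ->
  composableV a b x y -> composableV b c y z -> composableV (Nat.max a b) c (compV x y) z ->
  composableV a (Nat.max b c) x (compV y z) ->
  a = c -> a < b ->
  not_both_P (compV x y) z -> not_both_P x (compV y z) ->
  eqvV (Nat.max (Nat.max a b) c) (compV (compV x y) z) (compV x (compV y z)).
Proof.
  intros HN Ha Hb Hc Wx Wy Wz Cxy Cyz CL CR E1 E2 NL NR.
  pose proof (compV_wf a b x y Ha Hb Wx Wy Cxy) as Wxy.
  pose proof (compV_wf b c y z Hb Hc Wy Wz Cyz) as Wyz.
  pose proof (compV_wf (Nat.max a b) c _ z ltac:(lia) Hc Wxy Wz CL) as WL.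
  pose proof (compV_wf a (Nat.max b c) x _ Ha ltac:(lia) Wx Wyz CR) as WR.
  rewrite <- Nat.max_assoc.
  subst c. destruct b as [|b1]; [lia|]. simpl_max. destruct (eqvV_dim _ _ _ Wx) as [Dx _]. destruct (eqvV_dim _ _ _ Wy) as [Dy _].
  destruct (eqvV_dim _ _ _ Wz) as [Dz _]. destruct (eqvV_dim _ _ _ Wxy) as [Dxy _].
  destruct (eqvV_dim _ _ _ Wyz) as [Dyz _].
  rewrite (compV_gt (compV x y) z) by (auto; lia).
  rewrite (compV_lt x (compV y z)) in WR |- * by (auto; lia).
  destruct (composableV_faces_r a b1 x y) as [C1s C1t]; auto; try lia.
  destruct (composableV_faces_l b1 a y z) as [C2s C2t]; auto; try lia.
  destruct (composableV_faces_l b1 a (compV x y) z) as [C3s C3t]; auto; try lia.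
  destruct (composableV_faces_r a b1 x (compV y z)) as [C4s C4t]; auto; try lia.
  pose proof (srcV_cong _ _ _ Wy) as Wy1. pose proof (tgtV_cong _ _ _ Wy) as Wy2.
  pose proof (compV_wf a b1 x _ Ha ltac:(lia) Wx Wy1 C1s) as Wxy1.
  pose proof (compV_wf a b1 x _ Ha ltac:(lia) Wx Wy2 C1t) as Wxy2.
  pose proof (compV_wf b1 a _ z ltac:(lia) Ha Wy1 Wz C2s) as Wy1z.
  pose proof (compV_wf b1 a _ z ltac:(lia) Ha Wy2 Wz C2t) as Wy2z.
  simpl_max.
  pose proof (srcV_compV_lt a b1 x y ltac:(lia) Wx Wy Wxy Wxy1) as SXY.
  pose proof (tgtV_compV_lt a b1 x y ltac:(lia) Wx Wy Wxy Wxy2) as TXY.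
  pose proof (srcV_compV_gt b1 a y z ltac:(lia) Wy Wz Wyz Wy1z) as SYZ.
  pose proof (tgtV_compV_gt b1 a y z ltac:(lia) Wy Wz Wyz Wy2z) as TYZ.
  apply eqvV_VF_r; auto.
  * intro q. rewrite (cont_compV_lt x y ltac:(lia) q), (cont_compV_gt y z ltac:(lia) q). reflexivity.
  * eapply eqvV_trans.
    -- pose proof (compV_cong b1 a _ _ z z ltac:(lia) Ha SXY Wz C3s) as X. simpl_max. exact X.
    -- eapply eqvV_trans.
       ++ pose proof (IH a b1 a x (srcV y) z ltac:(lia) Ha ltac:(lia) Ha Wx Wy1 Wz) as X.
          simpl_max. apply X; auto; try lia.
          ** eapply composableV_cong; [exact SXY| exact Wz| exact C3s].
          ** eapply composableV_cong; [exact Wx| exact SYZ| exact C4s].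
       ++ pose proof (compV_cong a b1 x x _ _ Ha ltac:(lia) Wx (eqvV_sym _ _ _ SYZ)) as X.
          simpl_max. apply X. eapply composableV_cong; [exact Wx| exact SYZ| exact C4s].
  * eapply eqvV_trans.
    -- pose proof (compV_cong b1 a _ _ z z ltac:(lia) Ha TXY Wz C3t) as X. simpl_max. exact X.
    -- eapply eqvV_trans.
       ++ pose proof (IH a b1 a x (tgtV y) z ltac:(lia) Ha ltac:(lia) Ha Wx Wy2 Wz) as X.
          simpl_max. apply X; auto; try lia.
          ** eapply composableV_cong; [exact TXY| exact Wz| exact C3t].
          ** eapply composableV_cong; [exact Wx| exact TYZ| exact C4t].
       ++ pose proof (compV_cong a b1 x x _ _ Ha ltac:(lia) Wx (eqvV_sym _ _ _ TYZ)) as X.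
          simpl_max. apply X. eapply composableV_cong; [exact Wx| exact TYZ| exact C4t].
Qed.

Lemma compV_assoc_z_high a b c x y z : a + b + c <= S N -> 1 <= a -> 1 <= b -> 1 <= c ->
  eqvV a x x -> eqvV b y y -> eqvV c z z ->
  composableV a b x y -> composableV b c y z -> composableV (Nat.max a b) c (compV x y) z ->
  composableV a (Nat.max b c) x (compV y z) ->
  a = b -> a < c ->
  not_both_P (compV x y) z -> not_both_P x (compV y z) ->
  eqvV (Nat.max (Nat.max a b) c) (compV (compV x y) z) (compV x (compV y z)).
Proof.
  intros HN Ha Hb Hc Wx Wy Wz Cxy Cyz CL CR E1 E2 NL NR.
  pose proof (compV_wf a b x y Ha Hb Wx Wy Cxy) as Wxy.
  pose proof (compV_wf b c y z Hb Hc Wy Wz Cyz) as Wyz.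
  pose proof (compV_wf (Nat.max a b) c _ z ltac:(lia) Hc Wxy Wz CL) as WL.
  pose proof (compV_wf a (Nat.max b c) x _ Ha ltac:(lia) Wx Wyz CR) as WR.
  rewrite <- Nat.max_assoc.
  subst b. destruct c as [|c1]; [lia|]. simpl_max. destruct (eqvV_dim _ _ _ Wx) as [Dx _]. destruct (eqvV_dim _ _ _ Wy) as [Dy _].
  destruct (eqvV_dim _ _ _ Wz) as [Dz _]. destruct (eqvV_dim _ _ _ Wxy) as [Dxy _].
  destruct (eqvV_dim _ _ _ Wyz) as [Dyz _].
  rewrite (compV_lt (compV x y) z) by (auto; lia).
  rewrite (compV_lt x (compV y z)) in WR |- * by (auto; lia).
  destruct (composableV_faces_r a c1 y z) as [C1s C1t]; auto; try lia.
  destruct (composableV_faces_r a c1 (compV x y) z) as [C2s C2t]; auto; try lia.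
  destruct (composableV_faces_r a c1 x (compV y z)) as [C3s C3t]; auto; try lia.
  pose proof (srcV_cong _ _ _ Wz) as Wz1. pose proof (tgtV_cong _ _ _ Wz) as Wz2.
  pose proof (compV_wf a c1 y _ Ha ltac:(lia) Wy Wz1 C1s) as Wyz1.
  pose proof (compV_wf a c1 y _ Ha ltac:(lia) Wy Wz2 C1t) as Wyz2.
  simpl_max.
  pose proof (srcV_compV_lt a c1 y z ltac:(lia) Wy Wz Wyz Wyz1) as SYZ.
  pose proof (tgtV_compV_lt a c1 y z ltac:(lia) Wy Wz Wyz Wyz2) as TYZ.
  apply eqvV_VF_r; auto.
  * intro q. rewrite (cont_compV_lt y z ltac:(lia) q). reflexivity.
  * eapply eqvV_trans.
    -- pose proof (IH a a c1 x y (srcV z) ltac:(lia) Ha Ha ltac:(lia) Wx Wy Wz1) as X.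
       simpl_max. apply X; auto; try lia.
       eapply composableV_cong; [exact Wx| exact SYZ| exact C3s].
    -- pose proof (compV_cong a c1 x x _ _ Ha ltac:(lia) Wx (eqvV_sym _ _ _ SYZ)) as X.
       simpl_max. apply X. eapply composableV_cong; [exact Wx| exact SYZ| exact C3s].
  * eapply eqvV_trans.
    -- pose proof (IH a a c1 x y (tgtV z) ltac:(lia) Ha Ha ltac:(lia) Wx Wy Wz2) as X.
       simpl_max. apply X; auto; try lia.
       eapply composableV_cong; [exact Wx| exact TYZ| exact C3t].
    -- pose proof (compV_cong a c1 x x _ _ Ha ltac:(lia) Wx (eqvV_sym _ _ _ TYZ)) as X.
       simpl_max. apply X. eapply composableV_cong; [exact Wx| exact TYZ| exact C3t].
Qed.

End CompVAssoc.

Lemma compV_assoc a b c x y z : 1 <= a -> 1 <= b -> 1 <= c ->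
  eqvV a x x -> eqvV b y y -> eqvV c z z ->
  Nat.min a b = Nat.min b c -> Nat.min (Nat.max a b) c = Nat.min a b ->
  Nat.min a (Nat.max b c) = Nat.min a b ->
  composableV a b x y -> composableV b c y z -> composableV (Nat.max a b) c (compV x y) z ->
  composableV a (Nat.max b c) x (compV y z) ->
  eqvV (Nat.max (Nat.max a b) c) (compV (compV x y) z) (compV x (compV y z)).
Proof.
  revert a b c x y z.
  enough (G : forall N a b c x y z, a + b + c <= N -> 1 <= a -> 1 <= b -> 1 <= c ->
    eqvV a x x -> eqvV b y y -> eqvV c z z ->
    Nat.min a b = Nat.min b c -> Nat.min (Nat.max a b) c = Nat.min a b ->
    Nat.min a (Nat.max b c) = Nat.min a b ->
    composableV a b x y -> composableV b c y z -> composableV (Nat.max a b) c (compV x y) z ->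
    composableV a (Nat.max b c) x (compV y z) ->
    eqvV (Nat.max (Nat.max a b) c) (compV (compV x y) z) (compV x (compV y z))) by eauto.
  induction N as [|N IH]; intros a b c x y z HN Ha Hb Hc Wx Wy Wz M1 M2 M3 Cxy Cyz CL CR; [lia|].
  destruct (isP x && isP y && isP z) eqn:B; [eapply compV_assoc_P; eauto|].
  assert (NL : not_both_P (compV x y) z) by (unfold not_both_P; rewrite isP_compV; auto).
  assert (NR : not_both_P x (compV y z)) by (unfold not_both_P; rewrite isP_compV, andb_assoc; auto).
  assert (Cfg : (a = b /\ b = c) \/ (b = c /\ c < a) \/ (a = c /\ a < b) \/ (a = b /\ a < c)) by lia.
  destruct Cfg as [[E1 E2]|[[E1 E2]|[[E1 E2]|[E1 E2]]]].
  - eapply compV_assoc_eq; eauto.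
  - eapply compV_assoc_x_high; eauto.
  - eapply compV_assoc_y_high; eauto.
  - eapply compV_assoc_z_high; eauto.
Qed.

Section CompVDistrL.
Variable N : nat.
Hypothesis IH : forall a b c x y z, a + b + c <= N ->
  1 <= a -> eqvV a x x -> eqvV b y y -> eqvV c z z -> a < Nat.min b c -> composableV b c y z ->
  composableV a b x y -> composableV a c x z -> composableV a (Nat.max b c) x (compV y z) ->
  composableV (Nat.max a b) (Nat.max a c) (compV x y) (compV x z) ->
  eqvV (Nat.max a (Nat.max b c)) (compV x (compV y z)) (compV (compV x y) (compV x z)).

Lemma compV_distr_l_P a b c x y z :
  1 <= a -> eqvV a x x -> eqvV b y y -> eqvV c z z -> a < Nat.min b c -> composableV b c y z ->
  composableV a b x y -> composableV a c x z -> composableV a (Nat.max b c) x (compV y z) ->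
  composableV (Nat.max a b) (Nat.max a c) (compV x y) (compV x z) -> isP x && isP y && isP z = true ->
  eqvV (Nat.max a (Nat.max b c)) (compV x (compV y z)) (compV (compV x y) (compV x z)).
Proof.
  intros Ha Wx Wy Wz L Cyz Cxy Cxz CL CR B.
  pose proof (compV_wf b c y z ltac:(lia) ltac:(lia) Wy Wz Cyz) as Wyz.
  pose proof (compV_wf a b x y Ha ltac:(lia) Wx Wy Cxy) as Wxy.
  pose proof (compV_wf a c x z Ha ltac:(lia) Wx Wz Cxz) as Wxz.
  pose proof (compV_wf a (Nat.max b c) x _ Ha ltac:(lia) Wx Wyz CL) as WL.
  pose proof (compV_wf (Nat.max a b) (Nat.max a c) _ _ ltac:(lia) ltac:(lia) Wxy Wxz CR) as WR.
  simpl_max.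
  destruct x as [| |ka ta]; try discriminate. destruct y as [| |kb tb]; try discriminate.
  destruct z as [| |kc tc]; try discriminate. rewrite !compV_PP in *.
  apply eqvV_P in Wx. apply eqvV_P in Wy. apply eqvV_P in Wz.
  destruct Wx as [? [_ Wx]], Wy as [? [_ Wy]], Wz as [? [_ Wz]]. subst.
  apply eqvV_P in WL. apply eqvV_P in WR. destruct WL as [_ [_ WL]], WR as [_ [_ WR]].
  simpl_max. apply eqvV_P. repeat split; try lia. eapply e_distr_l; eauto.
Qed.

Lemma compV_distr_l_lt a b c x y z :
  a + b + c <= S N -> 1 <= a -> eqvV a x x -> eqvV b y y -> eqvV c z z -> a < Nat.min b c ->
  composableV b c y z -> composableV a b x y -> composableV a c x z ->
  composableV a (Nat.max b c) x (compV y z) ->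
  composableV (Nat.max a b) (Nat.max a c) (compV x y) (compV x z) -> b < c ->
  not_both_P x (compV y z) -> not_both_P (compV x y) (compV x z) ->
  eqvV (Nat.max a (Nat.max b c)) (compV x (compV y z)) (compV (compV x y) (compV x z)).
Proof.
  intros HN Ha Wx Wy Wz L Cyz Cxy Cxz CL CR E NL NR.
  pose proof (compV_wf b c y z ltac:(lia) ltac:(lia) Wy Wz Cyz) as Wyz.
  pose proof (compV_wf a b x y Ha ltac:(lia) Wx Wy Cxy) as Wxy.
  pose proof (compV_wf a c x z Ha ltac:(lia) Wx Wz Cxz) as Wxz.
  pose proof (compV_wf a (Nat.max b c) x _ Ha ltac:(lia) Wx Wyz CL) as WL.
  pose proof (compV_wf (Nat.max a b) (Nat.max a c) _ _ ltac:(lia) ltac:(lia) Wxy Wxz CR) as WR.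
  simpl_max.
  destruct (eqvV_dim _ _ _ Wx) as [Dx _]. destruct (eqvV_dim _ _ _ Wy) as [Dy _].
  destruct (eqvV_dim _ _ _ Wz) as [Dz _]. destruct (eqvV_dim _ _ _ Wxy) as [Dxy _].
  destruct (eqvV_dim _ _ _ Wyz) as [Dyz _]. destruct (eqvV_dim _ _ _ Wxz) as [Dxz _].
  simpl_max.
  destruct c as [|c1]; [lia|]. simpl_max.
  rewrite (compV_lt x (compV y z)) by (auto; lia).
  rewrite (compV_lt (compV x y) (compV x z)) in WR |- * by (auto; lia).
  destruct (composableV_faces_r b c1 y z) as [C1s C1t]; auto; try lia.
  destruct (composableV_faces_r a c1 x z) as [C2s C2t]; auto; try lia.
  destruct (composableV_faces_r a c1 x (compV y z)) as [C3s C3t]; auto; try lia.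
  destruct (composableV_faces_r b c1 (compV x y) (compV x z)) as [C4s C4t]; auto; try lia.
  pose proof (srcV_cong _ _ _ Wz) as Wz1. pose proof (tgtV_cong _ _ _ Wz) as Wz2.
  pose proof (compV_wf b c1 y _ ltac:(lia) ltac:(lia) Wy Wz1 C1s) as Wyz1.
  pose proof (compV_wf b c1 y _ ltac:(lia) ltac:(lia) Wy Wz2 C1t) as Wyz2.
  pose proof (compV_wf a c1 x _ ltac:(lia) ltac:(lia) Wx Wz1 C2s) as Wxz1.
  pose proof (compV_wf a c1 x _ ltac:(lia) ltac:(lia) Wx Wz2 C2t) as Wxz2.
  simpl_max.
  pose proof (srcV_compV_lt b c1 y z ltac:(lia) Wy Wz Wyz Wyz1) as SYZ.
  pose proof (tgtV_compV_lt b c1 y z ltac:(lia) Wy Wz Wyz Wyz2) as TYZ.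
  pose proof (srcV_compV_lt a c1 x z ltac:(lia) Wx Wz Wxz Wxz1) as SXZ.
  pose proof (tgtV_compV_lt a c1 x z ltac:(lia) Wx Wz Wxz Wxz2) as TXZ.
  apply eqvV_VF_r; auto.
  * intro q. rewrite (cont_compV_lt y z ltac:(lia) q), (cont_compV_lt x z ltac:(lia) q). reflexivity.
  * eapply eqvV_trans.
    -- pose proof (compV_cong a c1 x x _ _ Ha ltac:(lia) Wx SYZ C3s) as X. simpl_max. exact X.
    -- eapply eqvV_trans.
       ++ pose proof (IH a b c1 x y (srcV z) ltac:(lia) Ha Wx Wy Wz1 ltac:(lia) C1s Cxy C2s) as X.
          simpl_max. apply X.
          ** eapply composableV_cong; [exact Wx| exact SYZ| exact C3s].
          ** eapply composableV_cong; [exact Wxy| exact SXZ| exact C4s].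
       ++ pose proof (compV_cong b c1 _ _ _ _ ltac:(lia) ltac:(lia) Wxy (eqvV_sym _ _ _ SXZ)) as X.
          simpl_max. apply X. eapply composableV_cong; [exact Wxy| exact SXZ| exact C4s].
  * eapply eqvV_trans.
    -- pose proof (compV_cong a c1 x x _ _ Ha ltac:(lia) Wx TYZ C3t) as X. simpl_max. exact X.
    -- eapply eqvV_trans.
       ++ pose proof (IH a b c1 x y (tgtV z) ltac:(lia) Ha Wx Wy Wz2 ltac:(lia) C1t Cxy C2t) as X.
          simpl_max. apply X.
          ** eapply composableV_cong; [exact Wx| exact TYZ| exact C3t].
          ** eapply composableV_cong; [exact Wxy| exact TXZ| exact C4t].
       ++ pose proof (compV_cong b c1 _ _ _ _ ltac:(lia) ltac:(lia) Wxy (eqvV_sym _ _ _ TXZ)) as X.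
          simpl_max. apply X. eapply composableV_cong; [exact Wxy| exact TXZ| exact C4t].
Qed.

Lemma compV_distr_l_eq a b c x y z :
  a + b + c <= S N -> 1 <= a -> eqvV a x x -> eqvV b y y -> eqvV c z z -> a < Nat.min b c ->
  composableV b c y z -> composableV a b x y -> composableV a c x z ->
  composableV a (Nat.max b c) x (compV y z) ->
  composableV (Nat.max a b) (Nat.max a c) (compV x y) (compV x z) -> b = c ->
  not_both_P x (compV y z) -> not_both_P (compV x y) (compV x z) ->
  eqvV (Nat.max a (Nat.max b c)) (compV x (compV y z)) (compV (compV x y) (compV x z)).
Proof.
  intros HN Ha Wx Wy Wz L Cyz Cxy Cxz CL CR E NL NR.
  pose proof (compV_wf b c y z ltac:(lia) ltac:(lia) Wy Wz Cyz) as Wyz.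
  pose proof (compV_wf a b x y Ha ltac:(lia) Wx Wy Cxy) as Wxy.
  pose proof (compV_wf a c x z Ha ltac:(lia) Wx Wz Cxz) as Wxz.
  pose proof (compV_wf a (Nat.max b c) x _ Ha ltac:(lia) Wx Wyz CL) as WL.
  pose proof (compV_wf (Nat.max a b) (Nat.max a c) _ _ ltac:(lia) ltac:(lia) Wxy Wxz CR) as WR.
  simpl_max.
  destruct (eqvV_dim _ _ _ Wx) as [Dx _]. destruct (eqvV_dim _ _ _ Wy) as [Dy _].
  destruct (eqvV_dim _ _ _ Wz) as [Dz _]. destruct (eqvV_dim _ _ _ Wxy) as [Dxy _].
  destruct (eqvV_dim _ _ _ Wyz) as [Dyz _]. destruct (eqvV_dim _ _ _ Wxz) as [Dxz _].
  simpl_max.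
  rewrite <- E in *. clear E. rewrite ?Nat.max_id in *. destruct b as [|b1]; [lia|]. simpl_max.
  rewrite (compV_lt x (compV y z)) by (auto; lia).
  rewrite (compV_eq (compV x y) (compV x z)) in WR |- * by (auto; lia).
  destruct (composableV_faces_r a b1 x y) as [C1s C1t]; auto; try lia.
  destruct (composableV_faces_r a b1 x z) as [C2s C2t]; auto; try lia.
  destruct (composableV_faces_r a b1 x (compV y z)) as [C3s C3t]; auto; try lia.
  pose proof (srcV_cong _ _ _ Wy) as Wy1. pose proof (tgtV_cong _ _ _ Wz) as Wz2.
  pose proof (compV_wf a b1 x _ ltac:(lia) ltac:(lia) Wx Wy1 C1s) as Wxy1.
  pose proof (compV_wf a b1 x _ ltac:(lia) ltac:(lia) Wx Wz2 C2t) as Wxz2.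
  simpl_max.
  pose proof (srcV_compV_eq b1 y z Wy Wz Wyz) as SYZ.
  pose proof (tgtV_compV_eq b1 y z Wy Wz Wyz) as TYZ.
  pose proof (srcV_compV_lt a b1 x y ltac:(lia) Wx Wy Wxy Wxy1) as SXY.
  pose proof (tgtV_compV_lt a b1 x z ltac:(lia) Wx Wz Wxz Wxz2) as TXZ.
  apply eqvV_VF_r; auto.
  * intro q. rewrite (cont_compV_eq y z ltac:(lia) q), (cont_compV_lt x y ltac:(lia) q),
      (cont_compV_lt x z ltac:(lia) q). reflexivity.
  * eapply eqvV_trans.
    -- pose proof (compV_cong a b1 x x _ _ Ha ltac:(lia) Wx SYZ C3s) as X. simpl_max. exact X.
    -- apply eqvV_sym. exact SXY.
  * eapply eqvV_trans.
    -- pose proof (compV_cong a b1 x x _ _ Ha ltac:(lia) Wx TYZ C3t) as X. simpl_max. exact X.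
    -- apply eqvV_sym. exact TXZ.
Qed.

Lemma compV_distr_l_gt a b c x y z :
  a + b + c <= S N -> 1 <= a -> eqvV a x x -> eqvV b y y -> eqvV c z z -> a < Nat.min b c ->
  composableV b c y z -> composableV a b x y -> composableV a c x z ->
  composableV a (Nat.max b c) x (compV y z) ->
  composableV (Nat.max a b) (Nat.max a c) (compV x y) (compV x z) -> c < b ->
  not_both_P x (compV y z) -> not_both_P (compV x y) (compV x z) ->
  eqvV (Nat.max a (Nat.max b c)) (compV x (compV y z)) (compV (compV x y) (compV x z)).
Proof.
  intros HN Ha Wx Wy Wz L Cyz Cxy Cxz CL CR E NL NR.
  pose proof (compV_wf b c y z ltac:(lia) ltac:(lia) Wy Wz Cyz) as Wyz.
  pose proof (compV_wf a b x y Ha ltac:(lia) Wx Wy Cxy) as Wxy.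
  pose proof (compV_wf a c x z Ha ltac:(lia) Wx Wz Cxz) as Wxz.
  pose proof (compV_wf a (Nat.max b c) x _ Ha ltac:(lia) Wx Wyz CL) as WL.
  pose proof (compV_wf (Nat.max a b) (Nat.max a c) _ _ ltac:(lia) ltac:(lia) Wxy Wxz CR) as WR.
  simpl_max.
  destruct (eqvV_dim _ _ _ Wx) as [Dx _]. destruct (eqvV_dim _ _ _ Wy) as [Dy _].
  destruct (eqvV_dim _ _ _ Wz) as [Dz _]. destruct (eqvV_dim _ _ _ Wxy) as [Dxy _].
  destruct (eqvV_dim _ _ _ Wyz) as [Dyz _]. destruct (eqvV_dim _ _ _ Wxz) as [Dxz _].
  simpl_max.
  destruct b as [|b1]; [lia|]. simpl_max.
  rewrite (compV_lt x (compV y z)) by (auto; lia).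
  rewrite (compV_gt (compV x y) (compV x z)) in WR |- * by (auto; lia).
  destruct (composableV_faces_l b1 c y z) as [C1s C1t]; auto; try lia.
  destruct (composableV_faces_r a b1 x y) as [C2s C2t]; auto; try lia.
  destruct (composableV_faces_r a b1 x (compV y z)) as [C3s C3t]; auto; try lia.
  destruct (composableV_faces_l b1 c (compV x y) (compV x z)) as [C4s C4t]; auto; try lia.
  pose proof (srcV_cong _ _ _ Wy) as Wy1. pose proof (tgtV_cong _ _ _ Wy) as Wy2.
  pose proof (compV_wf b1 c _ z ltac:(lia) ltac:(lia) Wy1 Wz C1s) as Wy1z.
  pose proof (compV_wf b1 c _ z ltac:(lia) ltac:(lia) Wy2 Wz C1t) as Wy2z.
  pose proof (compV_wf a b1 x _ ltac:(lia) ltac:(lia) Wx Wy1 C2s) as Wxy1.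
  pose proof (compV_wf a b1 x _ ltac:(lia) ltac:(lia) Wx Wy2 C2t) as Wxy2.
  simpl_max.
  pose proof (srcV_compV_gt b1 c y z ltac:(lia) Wy Wz Wyz Wy1z) as SYZ.
  pose proof (tgtV_compV_gt b1 c y z ltac:(lia) Wy Wz Wyz Wy2z) as TYZ.
  pose proof (srcV_compV_lt a b1 x y ltac:(lia) Wx Wy Wxy Wxy1) as SXY.
  pose proof (tgtV_compV_lt a b1 x y ltac:(lia) Wx Wy Wxy Wxy2) as TXY.
  apply eqvV_VF_r; auto.
  * intro q. rewrite (cont_compV_gt y z ltac:(lia) q), (cont_compV_lt x y ltac:(lia) q). reflexivity.
  * eapply eqvV_trans.
    -- pose proof (compV_cong a b1 x x _ _ Ha ltac:(lia) Wx SYZ C3s) as X. simpl_max. exact X.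
    -- eapply eqvV_trans.
       ++ pose proof (IH a b1 c x (srcV y) z ltac:(lia) Ha Wx Wy1 Wz ltac:(lia) C1s C2s Cxz) as X.
          simpl_max. apply X.
          ** eapply composableV_cong; [exact Wx| exact SYZ| exact C3s].
          ** eapply composableV_cong; [exact SXY| exact Wxz| exact C4s].
       ++ pose proof (compV_cong b1 c _ _ _ _ ltac:(lia) ltac:(lia) (eqvV_sym _ _ _ SXY) Wxz) as X.
          simpl_max. apply X. eapply composableV_cong; [exact SXY| exact Wxz| exact C4s].
  * eapply eqvV_trans.
    -- pose proof (compV_cong a b1 x x _ _ Ha ltac:(lia) Wx TYZ C3t) as X. simpl_max. exact X.
    -- eapply eqvV_trans.
       ++ pose proof (IH a b1 c x (tgtV y) z ltac:(lia) Ha Wx Wy2 Wz ltac:(lia) C1t C2t Cxz) as X.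
          simpl_max. apply X.
          ** eapply composableV_cong; [exact Wx| exact TYZ| exact C3t].
          ** eapply composableV_cong; [exact TXY| exact Wxz| exact C4t].
       ++ pose proof (compV_cong b1 c _ _ _ _ ltac:(lia) ltac:(lia) (eqvV_sym _ _ _ TXY) Wxz) as X.
          simpl_max. apply X. eapply composableV_cong; [exact TXY| exact Wxz| exact C4t].
Qed.

End CompVDistrL.

Lemma compV_distr_l a b c x y z :
  1 <= a -> eqvV a x x -> eqvV b y y -> eqvV c z z -> a < Nat.min b c -> composableV b c y z ->
  composableV a b x y -> composableV a c x z -> composableV a (Nat.max b c) x (compV y z) ->
  composableV (Nat.max a b) (Nat.max a c) (compV x y) (compV x z) ->
  eqvV (Nat.max a (Nat.max b c)) (compV x (compV y z)) (compV (compV x y) (compV x z)).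
Proof.
  revert a b c x y z.
  enough (G : forall N a b c x y z, a + b + c <= N ->
    1 <= a -> eqvV a x x -> eqvV b y y -> eqvV c z z -> a < Nat.min b c -> composableV b c y z ->
    composableV a b x y -> composableV a c x z -> composableV a (Nat.max b c) x (compV y z) ->
    composableV (Nat.max a b) (Nat.max a c) (compV x y) (compV x z) ->
    eqvV (Nat.max a (Nat.max b c)) (compV x (compV y z)) (compV (compV x y) (compV x z))) by eauto.
  induction N as [|N IH]; intros a b c x y z HN Ha Wx Wy Wz L Cyz Cxy Cxz CL CR; [lia|].
  destruct (isP x && isP y && isP z) eqn:B; [eapply compV_distr_l_P; eauto|].
  assert (NL : not_both_P x (compV y z)) by (unfold not_both_P; rewrite isP_compV, andb_assoc; auto).
  assert (NR : not_both_P (compV x y) (compV x z)).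
  { unfold not_both_P. rewrite !isP_compV. destruct (isP x), (isP y), (isP z); auto. }
  destruct (lt_eq_lt_dec b c) as [[E|E]|E]; [eapply compV_distr_l_lt|eapply compV_distr_l_eq|eapply compV_distr_l_gt]; eauto.
Qed.

Section CompVDistrR.
Variable N : nat.
Hypothesis IH : forall a b c x y z, a + b + c <= N ->
  1 <= a -> eqvV a x x -> eqvV b y y -> eqvV c z z -> a < Nat.min b c -> composableV b c y z ->
  composableV b a y x -> composableV c a z x -> composableV (Nat.max b c) a (compV y z) x ->
  composableV (Nat.max b a) (Nat.max c a) (compV y x) (compV z x) ->
  eqvV (Nat.max (Nat.max b c) a) (compV (compV y z) x) (compV (compV y x) (compV z x)).

Lemma compV_distr_r_P a b c x y z :
  1 <= a -> eqvV a x x -> eqvV b y y -> eqvV c z z -> a < Nat.min b c -> composableV b c y z ->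
  composableV b a y x -> composableV c a z x -> composableV (Nat.max b c) a (compV y z) x ->
  composableV (Nat.max b a) (Nat.max c a) (compV y x) (compV z x) -> isP x && isP y && isP z = true ->
  eqvV (Nat.max (Nat.max b c) a) (compV (compV y z) x) (compV (compV y x) (compV z x)).
Proof.
  intros Ha Wx Wy Wz L Cyz Cyx Czx CL CR B.
  pose proof (compV_wf b c y z ltac:(lia) ltac:(lia) Wy Wz Cyz) as Wyz.
  pose proof (compV_wf b a y x ltac:(lia) Ha Wy Wx Cyx) as Wyx.
  pose proof (compV_wf c a z x ltac:(lia) Ha Wz Wx Czx) as Wzx.
  pose proof (compV_wf (Nat.max b c) a _ x ltac:(lia) Ha Wyz Wx CL) as WL.
  pose proof (compV_wf (Nat.max b a) (Nat.max c a) _ _ ltac:(lia) ltac:(lia) Wyx Wzx CR) as WR.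
  simpl_max.
  destruct x as [| |ka ta]; try discriminate. destruct y as [| |kb tb]; try discriminate.
  destruct z as [| |kc tc]; try discriminate. rewrite !compV_PP in *.
  apply eqvV_P in Wx. apply eqvV_P in Wy. apply eqvV_P in Wz.
  destruct Wx as [? [_ Wx]], Wy as [? [_ Wy]], Wz as [? [_ Wz]]. subst.
  apply eqvV_P in WL. apply eqvV_P in WR. destruct WL as [_ [_ WL]], WR as [_ [_ WR]].
  simpl_max. apply eqvV_P. repeat split; try lia. eapply e_distr_r; eauto.
Qed.

Lemma compV_distr_r_lt a b c x y z :
  a + b + c <= S N -> 1 <= a -> eqvV a x x -> eqvV b y y -> eqvV c z z -> a < Nat.min b c ->
  composableV b c y z -> composableV b a y x -> composableV c a z x ->
  composableV (Nat.max b c) a (compV y z) x ->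
  composableV (Nat.max b a) (Nat.max c a) (compV y x) (compV z x) -> b < c ->
  not_both_P (compV y z) x -> not_both_P (compV y x) (compV z x) ->
  eqvV (Nat.max (Nat.max b c) a) (compV (compV y z) x) (compV (compV y x) (compV z x)).
Proof.
  intros HN Ha Wx Wy Wz L Cyz Cyx Czx CL CR E NL NR.
  pose proof (compV_wf b c y z ltac:(lia) ltac:(lia) Wy Wz Cyz) as Wyz.
  pose proof (compV_wf b a y x ltac:(lia) Ha Wy Wx Cyx) as Wyx.
  pose proof (compV_wf c a z x ltac:(lia) Ha Wz Wx Czx) as Wzx.
  pose proof (compV_wf (Nat.max b c) a _ x ltac:(lia) Ha Wyz Wx CL) as WL.
  pose proof (compV_wf (Nat.max b a) (Nat.max c a) _ _ ltac:(lia) ltac:(lia) Wyx Wzx CR) as WR.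
  simpl_max.
  destruct (eqvV_dim _ _ _ Wx) as [Dx _]. destruct (eqvV_dim _ _ _ Wy) as [Dy _].
  destruct (eqvV_dim _ _ _ Wz) as [Dz _]. destruct (eqvV_dim _ _ _ Wyx) as [Dyx _].
  destruct (eqvV_dim _ _ _ Wyz) as [Dyz _]. destruct (eqvV_dim _ _ _ Wzx) as [Dzx _].
  simpl_max.
  destruct c as [|c1]; [lia|]. simpl_max.
  rewrite (compV_gt (compV y z) x) by (auto; lia).
  rewrite (compV_lt (compV y x) (compV z x)) in WR |- * by (auto; lia).
  destruct (composableV_faces_r b c1 y z) as [C1s C1t]; auto; try lia.
  destruct (composableV_faces_l c1 a z x) as [C2s C2t]; auto; try lia.
  destruct (composableV_faces_l c1 a (compV y z) x) as [C3s C3t]; auto; try lia.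
  destruct (composableV_faces_r b c1 (compV y x) (compV z x)) as [C4s C4t]; auto; try lia.
  pose proof (srcV_cong _ _ _ Wz) as Wz1. pose proof (tgtV_cong _ _ _ Wz) as Wz2.
  pose proof (compV_wf b c1 y _ ltac:(lia) ltac:(lia) Wy Wz1 C1s) as Wyz1.
  pose proof (compV_wf b c1 y _ ltac:(lia) ltac:(lia) Wy Wz2 C1t) as Wyz2.
  pose proof (compV_wf c1 a _ x ltac:(lia) ltac:(lia) Wz1 Wx C2s) as Wz1x.
  pose proof (compV_wf c1 a _ x ltac:(lia) ltac:(lia) Wz2 Wx C2t) as Wz2x.
  simpl_max.
  pose proof (srcV_compV_lt b c1 y z ltac:(lia) Wy Wz Wyz Wyz1) as SYZ.
  pose proof (tgtV_compV_lt b c1 y z ltac:(lia) Wy Wz Wyz Wyz2) as TYZ.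
  pose proof (srcV_compV_gt c1 a z x ltac:(lia) Wz Wx Wzx Wz1x) as SZX.
  pose proof (tgtV_compV_gt c1 a z x ltac:(lia) Wz Wx Wzx Wz2x) as TZX.
  apply eqvV_VF_r; auto.
  * intro q. rewrite (cont_compV_lt y z ltac:(lia) q), (cont_compV_gt z x ltac:(lia) q). reflexivity.
  * eapply eqvV_trans.
    -- pose proof (compV_cong c1 a _ _ x x ltac:(lia) Ha SYZ Wx C3s) as X. simpl_max. exact X.
    -- eapply eqvV_trans.
       ++ pose proof (IH a b c1 x y (srcV z) ltac:(lia) Ha Wx Wy Wz1 ltac:(lia) C1s Cyx C2s) as X.
          simpl_max. apply X.
          ** eapply composableV_cong; [exact SYZ| exact Wx| exact C3s].
          ** eapply composableV_cong; [exact Wyx| exact SZX| exact C4s].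
       ++ pose proof (compV_cong b c1 _ _ _ _ ltac:(lia) ltac:(lia) Wyx (eqvV_sym _ _ _ SZX)) as X.
          simpl_max. apply X. eapply composableV_cong; [exact Wyx| exact SZX| exact C4s].
  * eapply eqvV_trans.
    -- pose proof (compV_cong c1 a _ _ x x ltac:(lia) Ha TYZ Wx C3t) as X. simpl_max. exact X.
    -- eapply eqvV_trans.
       ++ pose proof (IH a b c1 x y (tgtV z) ltac:(lia) Ha Wx Wy Wz2 ltac:(lia) C1t Cyx C2t) as X.
          simpl_max. apply X.
          ** eapply composableV_cong; [exact TYZ| exact Wx| exact C3t].
          ** eapply composableV_cong; [exact Wyx| exact TZX| exact C4t].
       ++ pose proof (compV_cong b c1 _ _ _ _ ltac:(lia) ltac:(lia) Wyx (eqvV_sym _ _ _ TZX)) as X.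
          simpl_max. apply X. eapply composableV_cong; [exact Wyx| exact TZX| exact C4t].
Qed.

Lemma compV_distr_r_eq a b c x y z :
  a + b + c <= S N -> 1 <= a -> eqvV a x x -> eqvV b y y -> eqvV c z z -> a < Nat.min b c ->
  composableV b c y z -> composableV b a y x -> composableV c a z x ->
  composableV (Nat.max b c) a (compV y z) x ->
  composableV (Nat.max b a) (Nat.max c a) (compV y x) (compV z x) -> b = c ->
  not_both_P (compV y z) x -> not_both_P (compV y x) (compV z x) ->
  eqvV (Nat.max (Nat.max b c) a) (compV (compV y z) x) (compV (compV y x) (compV z x)).
Proof.
  intros HN Ha Wx Wy Wz L Cyz Cyx Czx CL CR E NL NR.
  pose proof (compV_wf b c y z ltac:(lia) ltac:(lia) Wy Wz Cyz) as Wyz.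
  pose proof (compV_wf b a y x ltac:(lia) Ha Wy Wx Cyx) as Wyx.
  pose proof (compV_wf c a z x ltac:(lia) Ha Wz Wx Czx) as Wzx.
  pose proof (compV_wf (Nat.max b c) a _ x ltac:(lia) Ha Wyz Wx CL) as WL.
  pose proof (compV_wf (Nat.max b a) (Nat.max c a) _ _ ltac:(lia) ltac:(lia) Wyx Wzx CR) as WR.
  simpl_max.
  destruct (eqvV_dim _ _ _ Wx) as [Dx _]. destruct (eqvV_dim _ _ _ Wy) as [Dy _].
  destruct (eqvV_dim _ _ _ Wz) as [Dz _]. destruct (eqvV_dim _ _ _ Wyx) as [Dyx _].
  destruct (eqvV_dim _ _ _ Wyz) as [Dyz _]. destruct (eqvV_dim _ _ _ Wzx) as [Dzx _].
  simpl_max.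
  rewrite <- E in *. clear E. rewrite ?Nat.max_id in *. destruct b as [|b1]; [lia|]. simpl_max.
  rewrite (compV_gt (compV y z) x) by (auto; lia).
  rewrite (compV_eq (compV y x) (compV z x)) in WR |- * by (auto; lia).
  destruct (composableV_faces_l b1 a y x) as [C1s C1t]; auto; try lia.
  destruct (composableV_faces_l b1 a z x) as [C2s C2t]; auto; try lia.
  destruct (composableV_faces_l b1 a (compV y z) x) as [C3s C3t]; auto; try lia.
  pose proof (srcV_cong _ _ _ Wy) as Wy1. pose proof (tgtV_cong _ _ _ Wz) as Wz2.
  pose proof (compV_wf b1 a _ x ltac:(lia) ltac:(lia) Wy1 Wx C1s) as Wy1x.
  pose proof (compV_wf b1 a _ x ltac:(lia) ltac:(lia) Wz2 Wx C2t) as Wz2x.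
  simpl_max.
  pose proof (srcV_compV_eq b1 y z Wy Wz Wyz) as SYZ.
  pose proof (tgtV_compV_eq b1 y z Wy Wz Wyz) as TYZ.
  pose proof (srcV_compV_gt b1 a y x ltac:(lia) Wy Wx Wyx Wy1x) as SYX.
  pose proof (tgtV_compV_gt b1 a z x ltac:(lia) Wz Wx Wzx Wz2x) as TZX.
  apply eqvV_VF_r; auto.
  * intro q. rewrite (cont_compV_eq y z ltac:(lia) q), (cont_compV_gt y x ltac:(lia) q),
      (cont_compV_gt z x ltac:(lia) q). reflexivity.
  * eapply eqvV_trans.
    -- pose proof (compV_cong b1 a _ _ x x ltac:(lia) Ha SYZ Wx C3s) as X. simpl_max. exact X.
    -- apply eqvV_sym. exact SYX.
  * eapply eqvV_trans.
    -- pose proof (compV_cong b1 a _ _ x x ltac:(lia) Ha TYZ Wx C3t) as X. simpl_max. exact X.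
    -- apply eqvV_sym. exact TZX.
Qed.

Lemma compV_distr_r_gt a b c x y z :
  a + b + c <= S N -> 1 <= a -> eqvV a x x -> eqvV b y y -> eqvV c z z -> a < Nat.min b c ->
  composableV b c y z -> composableV b a y x -> composableV c a z x ->
  composableV (Nat.max b c) a (compV y z) x ->
  composableV (Nat.max b a) (Nat.max c a) (compV y x) (compV z x) -> c < b ->
  not_both_P (compV y z) x -> not_both_P (compV y x) (compV z x) ->
  eqvV (Nat.max (Nat.max b c) a) (compV (compV y z) x) (compV (compV y x) (compV z x)).
Proof.
  intros HN Ha Wx Wy Wz L Cyz Cyx Czx CL CR E NL NR.
  pose proof (compV_wf b c y z ltac:(lia) ltac:(lia) Wy Wz Cyz) as Wyz.
  pose proof (compV_wf b a y x ltac:(lia) Ha Wy Wx Cyx) as Wyx.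
  pose proof (compV_wf c a z x ltac:(lia) Ha Wz Wx Czx) as Wzx.
  pose proof (compV_wf (Nat.max b c) a _ x ltac:(lia) Ha Wyz Wx CL) as WL.
  pose proof (compV_wf (Nat.max b a) (Nat.max c a) _ _ ltac:(lia) ltac:(lia) Wyx Wzx CR) as WR.
  simpl_max.
  destruct (eqvV_dim _ _ _ Wx) as [Dx _]. destruct (eqvV_dim _ _ _ Wy) as [Dy _].
  destruct (eqvV_dim _ _ _ Wz) as [Dz _]. destruct (eqvV_dim _ _ _ Wyx) as [Dyx _].
  destruct (eqvV_dim _ _ _ Wyz) as [Dyz _]. destruct (eqvV_dim _ _ _ Wzx) as [Dzx _].
  simpl_max.
  destruct b as [|b1]; [lia|]. simpl_max.
  rewrite (compV_gt (compV y z) x) by (auto; lia).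
  rewrite (compV_gt (compV y x) (compV z x)) in WR |- * by (auto; lia).
  destruct (composableV_faces_l b1 c y z) as [C1s C1t]; auto; try lia.
  destruct (composableV_faces_l b1 a y x) as [C2s C2t]; auto; try lia.
  destruct (composableV_faces_l b1 a (compV y z) x) as [C3s C3t]; auto; try lia.
  destruct (composableV_faces_l b1 c (compV y x) (compV z x)) as [C4s C4t]; auto; try lia.
  pose proof (srcV_cong _ _ _ Wy) as Wy1. pose proof (tgtV_cong _ _ _ Wy) as Wy2.
  pose proof (compV_wf b1 c _ z ltac:(lia) ltac:(lia) Wy1 Wz C1s) as Wy1z.
  pose proof (compV_wf b1 c _ z ltac:(lia) ltac:(lia) Wy2 Wz C1t) as Wy2z.
  pose proof (compV_wf b1 a _ x ltac:(lia) ltac:(lia) Wy1 Wx C2s) as Wy1x.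
  pose proof (compV_wf b1 a _ x ltac:(lia) ltac:(lia) Wy2 Wx C2t) as Wy2x.
  simpl_max.
  pose proof (srcV_compV_gt b1 c y z ltac:(lia) Wy Wz Wyz Wy1z) as SYZ.
  pose proof (tgtV_compV_gt b1 c y z ltac:(lia) Wy Wz Wyz Wy2z) as TYZ.
  pose proof (srcV_compV_gt b1 a y x ltac:(lia) Wy Wx Wyx Wy1x) as SYX.
  pose proof (tgtV_compV_gt b1 a y x ltac:(lia) Wy Wx Wyx Wy2x) as TYX.
  apply eqvV_VF_r; auto.
  * intro q. rewrite (cont_compV_gt y z ltac:(lia) q), (cont_compV_gt y x ltac:(lia) q). reflexivity.
  * eapply eqvV_trans.
    -- pose proof (compV_cong b1 a _ _ x x ltac:(lia) Ha SYZ Wx C3s) as X. simpl_max. exact X.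
    -- eapply eqvV_trans.
       ++ pose proof (IH a b1 c x (srcV y) z ltac:(lia) Ha Wx Wy1 Wz ltac:(lia) C1s C2s Czx) as X.
          simpl_max. apply X.
          ** eapply composableV_cong; [exact SYZ| exact Wx| exact C3s].
          ** eapply composableV_cong; [exact SYX| exact Wzx| exact C4s].
       ++ pose proof (compV_cong b1 c _ _ _ _ ltac:(lia) ltac:(lia) (eqvV_sym _ _ _ SYX) Wzx) as X.
          simpl_max. apply X. eapply composableV_cong; [exact SYX| exact Wzx| exact C4s].
  * eapply eqvV_trans.
    -- pose proof (compV_cong b1 a _ _ x x ltac:(lia) Ha TYZ Wx C3t) as X. simpl_max. exact X.
    -- eapply eqvV_trans.
       ++ pose proof (IH a b1 c x (tgtV y) z ltac:(lia) Ha Wx Wy2 Wz ltac:(lia) C1t C2t Czx) as X.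
          simpl_max. apply X.
          ** eapply composableV_cong; [exact TYZ| exact Wx| exact C3t].
          ** eapply composableV_cong; [exact TYX| exact Wzx| exact C4t].
       ++ pose proof (compV_cong b1 c _ _ _ _ ltac:(lia) ltac:(lia) (eqvV_sym _ _ _ TYX) Wzx) as X.
          simpl_max. apply X. eapply composableV_cong; [exact TYX| exact Wzx| exact C4t].
Qed.

End CompVDistrR.

Lemma compV_distr_r a b c x y z :
  1 <= a -> eqvV a x x -> eqvV b y y -> eqvV c z z -> a < Nat.min b c -> composableV b c y z ->
  composableV b a y x -> composableV c a z x -> composableV (Nat.max b c) a (compV y z) x ->
  composableV (Nat.max b a) (Nat.max c a) (compV y x) (compV z x) ->
  eqvV (Nat.max (Nat.max b c) a) (compV (compV y z) x) (compV (compV y x) (compV z x)).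
Proof.
  revert a b c x y z.
  enough (G : forall N a b c x y z, a + b + c <= N ->
    1 <= a -> eqvV a x x -> eqvV b y y -> eqvV c z z -> a < Nat.min b c -> composableV b c y z ->
    composableV b a y x -> composableV c a z x -> composableV (Nat.max b c) a (compV y z) x ->
    composableV (Nat.max b a) (Nat.max c a) (compV y x) (compV z x) ->
    eqvV (Nat.max (Nat.max b c) a) (compV (compV y z) x) (compV (compV y x) (compV z x))) by eauto.
  induction N as [|N IH]; intros a b c x y z HN Ha Wx Wy Wz L Cyz Cyx Czx CL CR; [lia|].
  destruct (isP x && isP y && isP z) eqn:B; [eapply compV_distr_r_P; eauto|].
  assert (NL : not_both_P (compV y z) x).
  { unfold not_both_P. rewrite !isP_compV. destruct (isP x), (isP y), (isP z); auto. }
  assert (NR : not_both_P (compV y x) (compV z x)).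
  { unfold not_both_P. rewrite !isP_compV. destruct (isP x), (isP y), (isP z); auto. }
  destruct (lt_eq_lt_dec b c) as [[E|E]|E]; [eapply compV_distr_r_lt|eapply compV_distr_r_eq|eapply compV_distr_r_gt]; eauto.
Qed.

End ValueModel.
Arguments compV : simpl never.
(** * Interpretation of Q^* in the model *)

Section Interpretation.
Context {n : nbar} {P Q : Pol n} (F : PolMor P Q) (c : nat).
Notation Y := (gen Q).
Notation val := (val P Y).
Notation eqvV := (eqvV P Y).
Notation srcV := (srcV P Y).
Notation tgtV := (tgtV P Y).
Notation idV := (idV P Y).
Notation compV := (compV P Y).
Notation dimV := (dimV P Y).
Notation composableV := (composableV P Y).

Definition preimage (q : Y) : option (gen P) :=
  match excluded_middle_informative (exists p, F p = q) with
  | left h => Some (proj1_sig (constructive_indefinite_description _ h))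
  | right _ => None
  end.

Lemma preimage_spec q p : preimage q = Some p -> F p = q.
Proof.
  unfold preimage. destruct excluded_middle_informative as [h|h]; [|discriminate].
  intros E; inversion E; subst. exact (proj2_sig (constructive_indefinite_description _ h)).
Qed.

Lemma preimage_image p : exists p', preimage (F p) = Some p' /\ F p' = F p.
Proof.
  unfold preimage. destruct excluded_middle_informative as [h|h].
  - eexists; split; [reflexivity|]. exact (proj2_sig (constructive_indefinite_description _ h)).
  - exfalso. apply h. eauto.
Qed.

(* The generators interpreted as cells of P^*; all others are foreign. *)
Definition preimage_below (q : Y) : option (gen P) :=
  match preimage q with Some p => if Nat.ltb (gdim Q q) c then Some p else None | None => None end.

Lemma preimage_below_spec q p : preimage_below q = Some p -> F p = q /\ gdim Q q < c /\ gdim P p = gdim Q q.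
Proof.
  unfold preimage_below. destruct (preimage q) eqn:E; [|discriminate].
  destruct (Nat.ltb_spec (gdim Q q) c) as [Hl|Hl]; [|discriminate]. intros H; inversion H; subst.
  apply preimage_spec in E. split; auto. split; auto. rewrite <- E. symmetry. apply pmap_dim.
Qed.

Definition indicator (q : Y) : content Y := fun x => if excluded_middle_informative (x = q) then 1 else 0.

Fixpoint evalV (g : Y -> val) (t : tm Y) : val :=
  match t with
  | tgen x => g x
  | tid a => idV (evalV g a)
  | tsrc a => srcV (evalV g a)
  | ttgt a => tgtV (evalV g a)
  | tcomp a b => compV (evalV g a) (evalV g b)
  end.

Fixpoint gval_fuel (f : nat) (q : Y) : val :=
  match f with
  | 0 => V0 P Y (indicator q)
  | S f' =>
    match preimage_below q with
    | Some p => VP P Y (gdim Q q) (tgen p)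
    | None => match gdim Q q with
              | 0 => V0 P Y (indicator q)
              | S _ => VF P Y (indicator q) (evalV (gval_fuel f') (gsrc Q q)) (evalV (gval_fuel f') (gtgt Q q))
              end
    end
  end.

Definition gval q := gval_fuel (S (gdim Q q)) q.
Definition valQ := evalV gval.

Lemma evalV_ext_below g g' k t : (forall x, gdim Q x <= k -> g x = g' x) ->
  tm_below (gdim Q) k t -> evalV g t = evalV g' t.
Proof. intros H. induction t; simpl; intros; try (f_equal; tauto). apply H; auto. Qed.

Lemma gval_fuel_stable f : forall f' q, gdim Q q < f -> gdim Q q < f' -> gval_fuel f q = gval_fuel f' q.
Proof.
  induction f as [|f IH]; intros f' q H1 H2; [lia|]. destruct f' as [|f']; [lia|].
  simpl. destruct (preimage_below q); auto. destruct (gdim Q q) as [|k] eqn:E; auto.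
  destruct (@gbelow n Q q k E) as [B1 B2].
  f_equal; apply evalV_ext_below with k; auto; intros x Hx; apply IH; lia.
Qed.

Lemma gval_unfold q : gval q = match preimage_below q with
    | Some p => VP P Y (gdim Q q) (tgen p)
    | None => match gdim Q q with
              | 0 => V0 P Y (indicator q)
              | S _ => VF P Y (indicator q) (valQ (gsrc Q q)) (valQ (gtgt Q q))
              end
    end.
Proof.
  unfold gval. simpl. destruct (preimage_below q); auto. destruct (gdim Q q) as [|k] eqn:E; auto.
  destruct (@gbelow n Q q k E) as [B1 B2]. unfold valQ.
  f_equal; apply evalV_ext_below with k; auto; intros x Hx; unfold gval; apply gval_fuel_stable; lia.
Qed.

Lemma valQ_gen x : valQ (tgen x) = gval x. Proof. reflexivity. Qed.
Lemma valQ_id t : valQ (tid t) = idV (valQ t). Proof. reflexivity. Qed.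
Lemma valQ_src t : valQ (tsrc t) = srcV (valQ t). Proof. reflexivity. Qed.
Lemma valQ_tgt t : valQ (ttgt t) = tgtV (valQ t). Proof. reflexivity. Qed.
Lemma valQ_comp t u : valQ (tcomp t u) = compV (valQ t) (valQ u). Proof. reflexivity. Qed.
Lemma valQ_iter_src m t : valQ (Nat.iter m (@tsrc _) t) = Nat.iter m srcV (valQ t).
Proof. induction m; simpl; auto. rewrite valQ_src, IHm. reflexivity. Qed.
Lemma valQ_iter_tgt m t : valQ (Nat.iter m (@ttgt _) t) = Nat.iter m tgtV (valQ t).
Proof. induction m; simpl; auto. rewrite valQ_tgt, IHm. reflexivity. Qed.

Global Opaque valQ.

(* [compV] is total, so soundness must record that each composite was defined. *)
Inductive wf_composites : tm Y -> Prop :=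
| wfc_gen x : (forall k, gdim Q x = S k -> wf_composites (gsrc Q x) /\ wf_composites (gtgt Q x)) -> wf_composites (tgen x)
| wfc_id t : wf_composites t -> wf_composites (tid t)
| wfc_src t : wf_composites t -> wf_composites (tsrc t)
| wfc_tgt t : wf_composites t -> wf_composites (ttgt t)
| wfc_comp a b : wf_composites a -> wf_composites b -> 1 <= dimV (valQ a) -> 1 <= dimV (valQ b) ->
    composableV (dimV (valQ a)) (dimV (valQ b)) (valQ a) (valQ b) -> wf_composites (tcomp a b).

Hypothesis Hboundary : forall q p k, preimage_below q = Some p -> gdim Q q = S k ->
  eqvV k (valQ (gsrc Q q)) (VP P Y k (gsrc P p)) /\ eqvV k (valQ (gtgt Q q)) (VP P Y k (gtgt P p)).

Definition sound_at j t u := eqvV j (valQ t) (valQ u) /\ wf_composites t /\ wf_composites u.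

Lemma wf_composites_tcomp_inv k l a b : eqvV k (valQ a) (valQ a) -> eqvV l (valQ b) (valQ b) -> wf_composites (tcomp a b) ->
  1 <= k /\ 1 <= l /\ composableV k l (valQ a) (valQ b) /\ wf_composites a /\ wf_composites b.
Proof.
  intros Ha Hb G. inversion G; subst.
  destruct (eqvV_dim _ _ _ _ _ Ha) as [Da _]. destruct (eqvV_dim _ _ _ _ _ Hb) as [Db _].
  rewrite Da, Db in *. auto.
Qed.

Lemma wf_composites_tgen_inv x k : wf_composites (tgen x) -> gdim Q x = S k -> wf_composites (gsrc Q x) /\ wf_composites (gtgt Q x).
Proof. intros G E. inversion G; subst. eauto. Qed.

Lemma sound_gen0 x : gdim Q x = 0 -> sound_at 0 (tgen x) (tgen x).
Proof.
  intros E. assert (G : wf_composites (tgen x)) by (constructor; intros k Ek; congruence).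
  split; auto. rewrite valQ_gen, gval_unfold.
  destruct (preimage_below x) eqn:I.
  - destruct (preimage_below_spec _ _ I) as [_ [_ Dp]]. rewrite E in *. apply eqvV_P. repeat split; auto.
    pose proof (gen_wf P g) as W. rewrite Dp in W. exact W.
  - rewrite E. simpl. intro; reflexivity.
Qed.

Lemma sound_genS x k : gdim Q x = S k -> sound_at k (gsrc Q x) (gsrc Q x) -> sound_at k (gtgt Q x) (gtgt Q x) ->
  (forall k', k = S k' -> sound_at k' (tsrc (gsrc Q x)) (tsrc (gtgt Q x)) /\ sound_at k' (ttgt (gsrc Q x)) (ttgt (gtgt Q x))) ->
  sound_at (S k) (tgen x) (tgen x).
Proof.
  intros E [W1 [G1 _]] [W2 [G2 _]] Gl.
  assert (G : wf_composites (tgen x)) by (constructor; intros k' Ek'; auto).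
  split; auto. rewrite valQ_gen, gval_unfold.
  destruct (preimage_below x) eqn:I.
  - destruct (preimage_below_spec _ _ I) as [_ [_ Dp]]. rewrite E in *. apply eqvV_P. repeat split; auto.
    pose proof (gen_wf P g) as W. rewrite Dp in W. exact W.
  - rewrite E. apply eqvV_VF_intro; auto. intro; reflexivity.
    intros k' Ek'. destruct (Gl k' Ek') as [[A _] [B _]]. rewrite valQ_src in A. rewrite valQ_tgt in B.
    rewrite !valQ_src in A. rewrite !valQ_tgt in B. auto.
Qed.

Lemma sound_id k t t' : leN (S k) n -> sound_at k t t' -> sound_at (S k) (tid t) (tid t').
Proof. intros L [H [G1 G2]]. split; [|split; constructor; auto]. rewrite !valQ_id. apply idV_cong; auto. Qed.
Lemma sound_src k t t' : sound_at (S k) t t' -> sound_at k (tsrc t) (tsrc t').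
Proof. intros [H [G1 G2]]. split; [|split; constructor; auto]. rewrite !valQ_src. apply srcV_cong; auto. Qed.
Lemma sound_tgt k t t' : sound_at (S k) t t' -> sound_at k (ttgt t) (ttgt t').
Proof. intros [H [G1 G2]]. split; [|split; constructor; auto]. rewrite !valQ_tgt. apply tgtV_cong; auto. Qed.

Lemma sound_comp k l t t' u u' : sound_at k t t' -> sound_at l u u' -> 1 <= k -> 1 <= l ->
  sound_at (Nat.min k l - 1) (Nat.iter (k - (Nat.min k l - 1)) (@ttgt _) t) (Nat.iter (l - (Nat.min k l - 1)) (@tsrc _) u) ->
  sound_at (Nat.max k l) (tcomp t u) (tcomp t' u').
Proof.
  intros [Ht [Gt Gt']] [Hu [Gu Gu']] Hk Hl [Hc _]. rewrite valQ_iter_src, valQ_iter_tgt in Hc.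
  destruct (eqvV_dim _ _ _ _ _ Ht) as [D1 D2]. destruct (eqvV_dim _ _ _ _ _ Hu) as [D3 D4].
  split; [|split].
  - rewrite !valQ_comp. apply compV_cong; auto.
  - constructor; auto; rewrite ?D1, ?D3; auto.
  - constructor; auto; rewrite ?D2, ?D4; auto. eapply composableV_cong; eauto.
Qed.

Lemma sound_sym k t u : sound_at k t u -> sound_at k u t.
Proof. intros [H [G1 G2]]. split; auto. apply eqvV_sym; auto. Qed.
Lemma sound_trans k t u v : sound_at k t u -> sound_at k u v -> sound_at k t v.
Proof. intros [H [G1 G2]] [H' [G1' G2']]. split; auto. eapply eqvV_trans; eauto. Qed.

Lemma sound_src_gen x k : gdim Q x = S k -> sound_at (S k) (tgen x) (tgen x) -> sound_at k (tsrc (tgen x)) (gsrc Q x).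
Proof.
  intros E [H [G _]]. destruct (wf_composites_tgen_inv _ _ G E) as [G1 G2].
  split; [|split; [constructor; auto| auto]]. rewrite valQ_src. rewrite valQ_gen, gval_unfold in *.
  destruct (preimage_below x) eqn:I.
  - destruct (preimage_below_spec _ _ I) as [_ [_ Dp]]. destruct (Hboundary _ _ _ I E) as [C1 _].
    rewrite E in *. eapply eqvV_trans; [|apply eqvV_sym; exact C1].
    apply eqvV_P. simpl. repeat split; auto. apply e_src_gen; [congruence|].
    pose proof (gen_wf P g) as W. rewrite Dp in W. rewrite ?E in W. exact W.
  - rewrite E in *. simpl srcV. apply eqvV_VF_elim in H. destruct H as [_ [H _]]. exact H.
Qed.
Lemma sound_tgt_gen x k : gdim Q x = S k -> sound_at (S k) (tgen x) (tgen x) -> sound_at k (ttgt (tgen x)) (gtgt Q x).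
Proof.
  intros E [H [G _]]. destruct (wf_composites_tgen_inv _ _ G E) as [G1 G2].
  split; [|split; [constructor; auto| auto]]. rewrite valQ_tgt. rewrite valQ_gen, gval_unfold in *.
  destruct (preimage_below x) eqn:I.
  - destruct (preimage_below_spec _ _ I) as [_ [_ Dp]]. destruct (Hboundary _ _ _ I E) as [_ C1].
    rewrite E in *. eapply eqvV_trans; [|apply eqvV_sym; exact C1].
    apply eqvV_P. simpl. repeat split; auto. apply e_tgt_gen; [congruence|].
    pose proof (gen_wf P g) as W. rewrite Dp in W. rewrite ?E in W. exact W.
  - rewrite E in *. simpl tgtV. apply eqvV_VF_elim in H. destruct H as [_ [_ [H _]]]. exact H.
Qed.

Lemma sound_src_id k t : leN (S k) n -> sound_at k t t -> sound_at k (tsrc (tid t)) t.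
Proof. intros L [H [G _]]. split; [|split; repeat constructor; auto]. rewrite valQ_src, valQ_id. apply srcV_idV; auto. Qed.
Lemma sound_tgt_id k t : leN (S k) n -> sound_at k t t -> sound_at k (ttgt (tid t)) t.
Proof. intros L [H [G _]]. split; [|split; repeat constructor; auto]. rewrite valQ_tgt, valQ_id. apply tgtV_idV; auto. Qed.

Lemma sound_glob_ss k t : sound_at (S (S k)) t t -> sound_at k (tsrc (tsrc t)) (tsrc (ttgt t)).
Proof. intros [H [G _]]. split; [|split; repeat constructor; auto]. rewrite !valQ_src, valQ_tgt. apply eqvV_glob; auto. Qed.
Lemma sound_glob_tt k t : sound_at (S (S k)) t t -> sound_at k (ttgt (tsrc t)) (ttgt (ttgt t)).
Proof. intros [H [G _]]. split; [|split; repeat constructor; auto]. rewrite !valQ_tgt, valQ_src. apply eqvV_glob; auto. Qed.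

Lemma sound_src_ceq k t u : sound_at (S k) t t -> sound_at (S k) u u -> sound_at (S k) (tcomp t u) (tcomp t u) ->
  sound_at k (tsrc (tcomp t u)) (tsrc t).
Proof.
  intros [Ht [Gt _]] [Hu [Gu _]] [Hc [Gc _]]. split; [|split; try constructor; auto].
  rewrite !valQ_src. rewrite valQ_comp in *. apply srcV_compV_eq; auto.
Qed.
Lemma sound_tgt_ceq k t u : sound_at (S k) t t -> sound_at (S k) u u -> sound_at (S k) (tcomp t u) (tcomp t u) ->
  sound_at k (ttgt (tcomp t u)) (ttgt u).
Proof.
  intros [Ht [Gt _]] [Hu [Gu _]] [Hc [Gc _]]. split; [|split; try constructor; auto].
  rewrite !valQ_tgt. rewrite valQ_comp in *. apply tgtV_compV_eq; auto.
Qed.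

Lemma sound_src_clt k l t u : sound_at k t t -> sound_at (S l) u u -> k < S l -> sound_at (S l) (tcomp t u) (tcomp t u) ->
  sound_at l (tcomp t (tsrc u)) (tcomp t (tsrc u)) -> sound_at l (tsrc (tcomp t u)) (tcomp t (tsrc u)).
Proof.
  intros [Ht [Gt _]] [Hu [Gu _]] L [Hc [Gc _]] [Hc' [Gc' _]]. split; [|split; [constructor; auto| auto]].
  rewrite valQ_src. rewrite !valQ_comp, valQ_src in *. apply srcV_compV_lt with k; auto.
Qed.
Lemma sound_tgt_clt k l t u : sound_at k t t -> sound_at (S l) u u -> k < S l -> sound_at (S l) (tcomp t u) (tcomp t u) ->
  sound_at l (tcomp t (ttgt u)) (tcomp t (ttgt u)) -> sound_at l (ttgt (tcomp t u)) (tcomp t (ttgt u)).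
Proof.
  intros [Ht [Gt _]] [Hu [Gu _]] L [Hc [Gc _]] [Hc' [Gc' _]]. split; [|split; [constructor; auto| auto]].
  rewrite valQ_tgt. rewrite !valQ_comp, valQ_tgt in *. apply tgtV_compV_lt with k; auto.
Qed.
Lemma sound_src_cgt k l t u : sound_at (S k) t t -> sound_at l u u -> l < S k -> sound_at (S k) (tcomp t u) (tcomp t u) ->
  sound_at k (tcomp (tsrc t) u) (tcomp (tsrc t) u) -> sound_at k (tsrc (tcomp t u)) (tcomp (tsrc t) u).
Proof.
  intros [Ht [Gt _]] [Hu [Gu _]] L [Hc [Gc _]] [Hc' [Gc' _]]. split; [|split; [constructor; auto| auto]].
  rewrite valQ_src. rewrite !valQ_comp, valQ_src in *. apply srcV_compV_gt with l; auto.
Qed.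
Lemma sound_tgt_cgt k l t u : sound_at (S k) t t -> sound_at l u u -> l < S k -> sound_at (S k) (tcomp t u) (tcomp t u) ->
  sound_at k (tcomp (ttgt t) u) (tcomp (ttgt t) u) -> sound_at k (ttgt (tcomp t u)) (tcomp (ttgt t) u).
Proof.
  intros [Ht [Gt _]] [Hu [Gu _]] L [Hc [Gc _]] [Hc' [Gc' _]]. split; [|split; [constructor; auto| auto]].
  rewrite valQ_tgt. rewrite !valQ_comp, valQ_tgt in *. apply tgtV_compV_gt with l; auto.
Qed.

Lemma sound_unit_l k i u : leN k n -> sound_at k u u -> i < k ->
  sound_at k (tcomp (tid (Nat.iter (k - i) (@tsrc _) u)) u) (tcomp (tid (Nat.iter (k - i) (@tsrc _) u)) u) ->
  sound_at k (tcomp (tid (Nat.iter (k - i) (@tsrc _) u)) u) u.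
Proof.
  intros L [Hu [Gu _]] Hi [_ [Gc _]]. split; [|split; auto].
  rewrite valQ_comp, valQ_id, valQ_iter_src. apply (compV_unit_l P Y k _ _ i); auto.
  pose proof (iter_srcV_cong P Y (k - i) k _ _ ltac:(lia) Hu) as X.
  replace (k - (k - i)) with i in X by lia. exact X.
Qed.
Lemma sound_unit_r k i u : leN k n -> sound_at k u u -> i < k ->
  sound_at k (tcomp u (tid (Nat.iter (k - i) (@ttgt _) u))) (tcomp u (tid (Nat.iter (k - i) (@ttgt _) u))) ->
  sound_at k (tcomp u (tid (Nat.iter (k - i) (@ttgt _) u))) u.
Proof.
  intros L [Hu [Gu _]] Hi [_ [Gc _]]. split; [|split; auto].
  rewrite valQ_comp, valQ_id, valQ_iter_tgt. apply (compV_unit_r P Y k _ _ i); auto.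
  pose proof (iter_tgtV_cong P Y (k - i) k _ _ ltac:(lia) Hu) as X.
  replace (k - (k - i)) with i in X by lia. exact X.
Qed.

Lemma sound_idc_l k l t u : sound_at k t t -> sound_at l u u -> l <= k -> leN (S k) n ->
  sound_at k (tcomp t u) (tcomp t u) -> sound_at (S k) (tcomp (tid t) u) (tcomp (tid t) u) ->
  sound_at (S k) (tid (tcomp t u)) (tcomp (tid t) u).
Proof.
  intros [Ht [Gt _]] [Hu [Gu _]] L N0 [_ [Gc _]] [_ [Gc' _]].
  destruct (wf_composites_tcomp_inv _ _ _ _ Ht Hu Gc) as [H1 [H2 [C _]]].
  split; [|split; [constructor|]; auto].
  rewrite valQ_id, !valQ_comp, valQ_id. apply (idV_compV_l P Y k l); auto.
Qed.
Lemma sound_idc_r k l t u : sound_at k t t -> sound_at l u u -> k <= l -> leN (S l) n ->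
  sound_at l (tcomp t u) (tcomp t u) -> sound_at (S l) (tcomp t (tid u)) (tcomp t (tid u)) ->
  sound_at (S l) (tid (tcomp t u)) (tcomp t (tid u)).
Proof.
  intros [Ht [Gt _]] [Hu [Gu _]] L N0 [_ [Gc _]] [_ [Gc' _]].
  destruct (wf_composites_tcomp_inv _ _ _ _ Ht Hu Gc) as [H1 [H2 [C _]]].
  split; [|split; [constructor|]; auto].
  rewrite valQ_id, !valQ_comp, valQ_id. apply (idV_compV_r P Y k l); auto.
Qed.

Lemma sound_assoc a b c0 m t u v : sound_at a t t -> sound_at b u u -> sound_at c0 v v ->
  Nat.min a b = Nat.min b c0 -> Nat.min (Nat.max a b) c0 = Nat.min a b ->
  Nat.min a (Nat.max b c0) = Nat.min a b ->
  sound_at m (tcomp (tcomp t u) v) (tcomp (tcomp t u) v) -> sound_at m (tcomp t (tcomp u v)) (tcomp t (tcomp u v)) ->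
  sound_at m (tcomp (tcomp t u) v) (tcomp t (tcomp u v)).
Proof.
  intros [Ht [Gt _]] [Hu [Gu _]] [Hv [Gv _]] M1 M2 M3 [HL [GL _]] [HR [GR _]].
  split; auto.
  inversion GL as [| | | |a1 b1 Gtu Gv' _ _ _]; subst.
  inversion GR as [| | | |a1 b1 Gt' Guv _ _ _]; subst.
  destruct (wf_composites_tcomp_inv _ _ _ _ Ht Hu Gtu) as [Ha [Hb [Ctu _]]].
  destruct (wf_composites_tcomp_inv _ _ _ _ Hu Hv Guv) as [_ [Hc [Cuv _]]].
  pose proof (compV_wf P Y _ _ _ _ Ha Hb Ht Hu Ctu) as Wtu.
  pose proof (compV_wf P Y _ _ _ _ Hb Hc Hu Hv Cuv) as Wuv.
  rewrite <- valQ_comp in Wtu, Wuv.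
  destruct (wf_composites_tcomp_inv _ _ _ _ Wtu Hv GL) as [_ [_ [CL _]]].
  destruct (wf_composites_tcomp_inv _ _ _ _ Ht Wuv GR) as [_ [_ [CR _]]].
  rewrite !valQ_comp in *.
  pose proof (compV_assoc P Y a b c0 _ _ _ Ha Hb Hc Ht Hu Hv M1 M2 M3 Ctu Cuv CL CR) as X.
  destruct (eqvV_dim _ _ _ _ _ HL) as [D1 _]. destruct (eqvV_dim _ _ _ _ _ X) as [D2 _].
  rewrite D1 in D2. rewrite D2. exact X.
Qed.

Lemma sound_distr_l a b c0 m t u v : sound_at a t t -> sound_at b u u -> sound_at c0 v v -> a < Nat.min b c0 ->
  sound_at m (tcomp t (tcomp u v)) (tcomp t (tcomp u v)) ->
  sound_at m (tcomp (tcomp t u) (tcomp t v)) (tcomp (tcomp t u) (tcomp t v)) ->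
  sound_at m (tcomp t (tcomp u v)) (tcomp (tcomp t u) (tcomp t v)).
Proof.
  intros [Ht [Gt _]] [Hu [Gu _]] [Hv [Gv _]] L [HL [GL _]] [HR [GR _]].
  split; auto.
  inversion GL as [| | | |a1 b1 Gt' Guv _ _ _]; subst.
  inversion GR as [| | | |a1 b1 Gtu Gtv _ _ _]; subst.
  destruct (wf_composites_tcomp_inv _ _ _ _ Hu Hv Guv) as [Hb [Hc [Cuv _]]].
  destruct (wf_composites_tcomp_inv _ _ _ _ Ht Hu Gtu) as [Ha [_ [Ctu _]]].
  destruct (wf_composites_tcomp_inv _ _ _ _ Ht Hv Gtv) as [_ [_ [Ctv _]]].
  pose proof (compV_wf P Y _ _ _ _ Hb Hc Hu Hv Cuv) as Wuv.
  pose proof (compV_wf P Y _ _ _ _ Ha Hb Ht Hu Ctu) as Wtu.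
  pose proof (compV_wf P Y _ _ _ _ Ha Hc Ht Hv Ctv) as Wtv.
  rewrite <- valQ_comp in Wtu, Wuv, Wtv.
  destruct (wf_composites_tcomp_inv _ _ _ _ Ht Wuv GL) as [_ [_ [CL _]]].
  destruct (wf_composites_tcomp_inv _ _ _ _ Wtu Wtv GR) as [_ [_ [CR _]]].
  rewrite !valQ_comp in *.
  pose proof (compV_distr_l P Y a b c0 _ _ _ Ha Ht Hu Hv L Cuv Ctu Ctv CL CR) as X.
  destruct (eqvV_dim _ _ _ _ _ HL) as [D1 _]. destruct (eqvV_dim _ _ _ _ _ X) as [D2 _].
  rewrite D1 in D2. rewrite D2. exact X.
Qed.

Lemma sound_distr_r a b c0 m t u v : sound_at a t t -> sound_at b u u -> sound_at c0 v v -> a < Nat.min b c0 ->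
  sound_at m (tcomp (tcomp u v) t) (tcomp (tcomp u v) t) ->
  sound_at m (tcomp (tcomp u t) (tcomp v t)) (tcomp (tcomp u t) (tcomp v t)) ->
  sound_at m (tcomp (tcomp u v) t) (tcomp (tcomp u t) (tcomp v t)).
Proof.
  intros [Ht [Gt _]] [Hu [Gu _]] [Hv [Gv _]] L [HL [GL _]] [HR [GR _]].
  split; auto.
  inversion GL as [| | | |a1 b1 Guv Gt' _ _ _]; subst.
  inversion GR as [| | | |a1 b1 Gut Gvt _ _ _]; subst.
  destruct (wf_composites_tcomp_inv _ _ _ _ Hu Hv Guv) as [Hb [Hc [Cuv _]]].
  destruct (wf_composites_tcomp_inv _ _ _ _ Hu Ht Gut) as [_ [Ha [Cut _]]].
  destruct (wf_composites_tcomp_inv _ _ _ _ Hv Ht Gvt) as [_ [_ [Cvt _]]].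
  pose proof (compV_wf P Y _ _ _ _ Hb Hc Hu Hv Cuv) as Wuv.
  pose proof (compV_wf P Y _ _ _ _ Hb Ha Hu Ht Cut) as Wut.
  pose proof (compV_wf P Y _ _ _ _ Hc Ha Hv Ht Cvt) as Wvt.
  rewrite <- valQ_comp in Wut, Wuv, Wvt.
  destruct (wf_composites_tcomp_inv _ _ _ _ Wuv Ht GL) as [_ [_ [CL _]]].
  destruct (wf_composites_tcomp_inv _ _ _ _ Wut Wvt GR) as [_ [_ [CR _]]].
  rewrite !valQ_comp in *.
  pose proof (compV_distr_r P Y a b c0 _ _ _ Ha Ht Hu Hv L Cuv Cut Cvt CL CR) as X.
  destruct (eqvV_dim _ _ _ _ _ HL) as [D1 _]. destruct (eqvV_dim _ _ _ _ _ X) as [D2 _].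
  rewrite D1 in D2. rewrite D2. exact X.
Qed.

Lemma eqv_sound : forall j t u, eqv n Y (gdim Q) (gsrc Q) (gtgt Q) j t u -> sound_at j t u.
Proof.
  fix IH 4. intros j t u H. destruct H;
  repeat match goal with Hh : eqv n Y (gdim Q) (gsrc Q) (gtgt Q) _ _ _ |- _ =>
     let h := fresh "IHe" in pose proof (IH _ _ _ Hh) as h; revert Hh end; intros.
  - apply sound_gen0; auto.
  - apply sound_genS; auto. intros k' Ek'.
    match goal with Hg : forall k0, _ -> _ /\ _ |- _ =>
      destruct (Hg k' Ek') as [G1 G2]; split; [exact (IH _ _ _ G1)| exact (IH _ _ _ G2)] end.
  - apply sound_id; auto.
  - apply sound_src; auto.
  - apply sound_tgt; auto.
  - apply sound_comp; auto.
  - apply sound_sym; auto.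
  - eapply sound_trans; eauto.
  - apply sound_src_gen; auto.
  - apply sound_tgt_gen; auto.
  - apply sound_src_id; auto.
  - apply sound_tgt_id; auto.
  - apply sound_glob_ss; auto.
  - apply sound_glob_tt; auto.
  - apply sound_src_ceq; auto.
  - apply sound_tgt_ceq; auto.
  - eapply sound_src_clt; eauto.
  - eapply sound_tgt_clt; eauto.
  - eapply sound_src_cgt; eauto.
  - eapply sound_tgt_cgt; eauto.
  - apply sound_unit_l; auto. eapply eqv_dim_leN; [apply gdim_le|]. eassumption.
  - apply sound_unit_r; auto. eapply eqv_dim_leN; [apply gdim_le|]. eassumption.
  - eapply sound_idc_l; eauto.
  - eapply sound_idc_r; eauto.
  - eapply sound_assoc; eauto.
  - eapply sound_distr_l; eauto.
  - eapply sound_distr_r; eauto.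
Qed.

End Interpretation.

(** * Reflection of equality along injective morphisms *)

Section Reflection.
Context {n : nbar} {P Q : Pol n} (F : PolMor P Q).
Notation Y := (gen Q).
Notation eqvV := (eqvV P Y).

Lemma valQ_ext_below c1 c2 k t : (forall x, gdim Q x <= k -> gval F c1 x = gval F c2 x) ->
  tm_below (gdim Q) k t -> valQ F c1 t = valQ F c2 t.
Proof.
  intros H. induction t; simpl; intros B.
  - rewrite !valQ_gen. auto.
  - rewrite !valQ_id. f_equal; auto.
  - rewrite !valQ_src. f_equal; auto.
  - rewrite !valQ_tgt. f_equal; auto.
  - rewrite !valQ_comp. destruct B. f_equal; auto.
Qed.

Lemma gval_cutoff_irrelevant c1 c2 : forall d q, gdim Q q = d -> d < c1 -> d < c2 -> gval F c1 q = gval F c2 q.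
Proof.
  intros d. induction d as [d IH] using (well_founded_induction lt_wf). intros q E H1 H2.
  rewrite !gval_unfold. unfold preimage_below.
  destruct (Nat.ltb_spec (gdim Q q) c1); [|lia]. destruct (Nat.ltb_spec (gdim Q q) c2); [|lia].
  destruct (preimage F q); auto. destruct (gdim Q q) as [|k] eqn:Eq; auto.
  destruct (@gbelow n Q q k Eq) as [B1 B2].
  f_equal; apply valQ_ext_below with k; auto; intros x Hx; apply (IH (gdim Q x)); auto; lia.
Qed.

Definition injective_below c := forall p p', gdim P p < c -> F p = F p' -> p = p'.

Lemma valQ_tmap c k t : injective_below c -> k < c -> tm_below (gdim P) k t ->
  valQ F c (tmap F t) = VP P Y (tm_dim (gdim P) t) t.
Proof.
  intros I L. induction t; simpl; intros B.
  - rewrite valQ_gen, gval_unfold. unfold preimage_below.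
    destruct (preimage_image F x) as [p' [E1 E2]]. rewrite E1.
    assert (Dp : gdim P p' = gdim P x).
    { rewrite <- (@pmap_dim _ _ _ F p'), E2, (@pmap_dim _ _ _ F x). reflexivity. }
    apply I in E2; [|lia].
    subst p'. rewrite (@pmap_dim _ _ _ F x). destruct (Nat.ltb_spec (gdim P x) c); [reflexivity| lia].
  - rewrite valQ_id, IHt; auto.
  - rewrite valQ_src, IHt; auto.
  - rewrite valQ_tgt, IHt; auto.
  - destruct B. rewrite valQ_comp, IHt1, IHt2; auto.
Qed.

Definition boundary_agreement c := forall q p k, preimage_below F c q = Some p -> gdim Q q = S k ->
  eqvV k (valQ F c (gsrc Q q)) (VP P Y k (gsrc P p)) /\ eqvV k (valQ F c (gtgt Q q)) (VP P Y k (gtgt P p)).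

Lemma boundary_agreement_of_injective c : injective_below c -> boundary_agreement c.
Proof.
  induction c as [c IH] using (well_founded_induction lt_wf). intros I q p k Ei Ek.
  destruct (preimage_below_spec F c q p Ei) as [Fp [Lc Dp]].
  assert (I' : injective_below (S k)) by (intros a b Ha; apply I; lia).
  assert (C' : boundary_agreement (S k)) by (apply IH; auto; lia).
  rewrite Ek in Dp.
  destruct (@gbelow n P p k Dp) as [BP1 BP2]. destruct (@gbelow n Q q k Ek) as [BQ1 BQ2].
  assert (AG : forall t, tm_below (gdim Q) k t -> valQ F c t = valQ F (S k) t).
  { intros t Bt. apply valQ_ext_below with k; auto. intros x Hx. apply (gval_cutoff_irrelevant c (S k) (gdim Q x)); auto; lia. }
  split.
  - pose proof (@pmap_src _ _ _ F p k Dp) as S1. rewrite Fp in S1.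
    destruct (eqv_sound F (S k) C' _ _ _ S1) as [X _].
    rewrite (valQ_tmap (S k) k) in X; auto. rewrite AG; auto.
    apply eqvV_sym. destruct (valQ F (S k) (gsrc Q q)) eqn:Ev; try (destruct k; simpl in X; tauto).
    apply eqvV_P in X. destruct X as [E1 [E2 X]]. apply eqvV_P. repeat split; auto; try lia; rewrite <- E1 in *; apply e_sym; auto.
  - pose proof (@pmap_tgt _ _ _ F p k Dp) as S1. rewrite Fp in S1.
    destruct (eqv_sound F (S k) C' _ _ _ S1) as [X _].
    rewrite (valQ_tmap (S k) k) in X; auto. rewrite AG; auto.
    apply eqvV_sym. destruct (valQ F (S k) (gtgt Q q)) eqn:Ev; try (destruct k; simpl in X; tauto).
    apply eqvV_P in X. destruct X as [E1 [E2 X]]. apply eqvV_P. repeat split; auto; try lia; rewrite <- E1 in *; apply e_sym; auto.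
Qed.

Lemma eqv_reflect c k j t u : injective_below c -> k < c -> tm_below (gdim P) k t -> tm_below (gdim P) k u ->
  peqv Q j (tmap F t) (tmap F u) -> peqv P j t u.
Proof.
  intros I L Bt Bu H. destruct (eqv_sound F c (boundary_agreement_of_injective c I) _ _ _ H) as [X _].
  rewrite !(valQ_tmap c k) in X; auto. apply eqvV_P in X. tauto.
Qed.

Lemma boundaries_of_equal_images c k x y : injective_below c -> k < c ->
  gdim P x = S k -> gdim P y = S k -> F x = F y ->
  peqv P k (gsrc P x) (gsrc P y) /\ peqv P k (gtgt P x) (gtgt P y).
Proof.
  intros I L Ex Ey E.
  destruct (@gbelow n P x k Ex) as [Bx1 Bx2]. destruct (@gbelow n P y k Ey) as [By1 By2].
  split; apply (eqv_reflect c k); auto.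
  - eapply e_trans; [apply (@pmap_src _ _ _ F x k Ex)|]. rewrite E. apply e_sym, (@pmap_src _ _ _ F y k Ey).
  - eapply e_trans; [apply (@pmap_tgt _ _ _ F x k Ex)|]. rewrite E. apply e_sym, (@pmap_tgt _ _ _ F y k Ey).
Qed.

End Reflection.

(** * Monomorphisms *)

Definition pol_idmor {n} (P : Pol n) : PolMor P P.
Proof.
  refine (@Build_PolMor n P P (fun x => x) (fun _ => eq_refl) _ _).
  - intros x k E. rewrite tmap_id. exact (proj1 (@gwf n P x k E)).
  - intros x k E. rewrite tmap_id. exact (proj2 (@gwf n P x k E)).
Defined.

(* With cutoff 0 every generator is foreign, and the content of [tgen a] is the
   indicator of [a]. *)
Lemma peqv_tgen_inj {n} (P : Pol n) j a b : peqv P j (tgen a) (tgen b) -> a = b.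
Proof.
  intros H.
  assert (C : boundary_agreement (pol_idmor P) 0).
  { intros q p k Ei _. destruct (preimage_below_spec _ _ _ _ Ei) as [_ [L _]]. lia. }
  destruct (eqv_sound (pol_idmor P) 0 C _ _ _ H) as [X _].
  apply cont_eqvV in X. specialize (X a).
  rewrite !valQ_gen, !gval_unfold in X. unfold preimage_below in X.
  assert (K : forall q, Nat.ltb (gdim P q) 0 = false) by (intros; apply Nat.ltb_ge; lia).
  rewrite !K in X. destruct (preimage (pol_idmor P) a), (preimage (pol_idmor P) b);
  destruct (gdim P a), (gdim P b); simpl in X; unfold indicator in X;
  destruct (excluded_middle_informative (a = a)) as [_|C']; try congruence;
  destruct (excluded_middle_informative (a = b)); congruence.
Qed.

Section Duplicate.
Context {n : nbar} (P : Pol n) (x : gen P).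

(* [option (gen P)] adds a copy [None] of the generator [x]. *)
Definition dup_dim (o : option (gen P)) := match o with Some p => gdim P p | None => gdim P x end.
Definition dup_src (o : option (gen P)) := match o with Some p => tmap Some (gsrc P p) | None => tmap Some (gsrc P x) end.
Definition dup_tgt (o : option (gen P)) := match o with Some p => tmap Some (gtgt P p) | None => tmap Some (gtgt P x) end.

Lemma peqv_tmap_Some j t u : peqv P j t u -> eqv n (option (gen P)) dup_dim dup_src dup_tgt j (tmap Some t) (tmap Some u).
Proof. apply eqv_tmap_strict; auto. Qed.

Lemma tm_below_tmap_Some k t : tm_below (gdim P) k t -> tm_below dup_dim k (tmap Some t).
Proof. induction t; simpl; intuition. Qed.

Definition pol_dup : Pol n.
Proof.
  refine (@Build_Pol n (option (gen P)) dup_dim dup_src dup_tgt _ _ _ _).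
  - intros [p|]; apply gdim_le.
  - intros [p|] k E; simpl in *; destruct (@gbelow n P _ k E); split; apply tm_below_tmap_Some; auto.
  - intros [p|] k E; simpl in *; destruct (@gwf n P _ k E); split; apply peqv_tmap_Some; auto.
  - intros [p|] k E; simpl in *; destruct (@gglob n P _ k E) as [A B];
      split; first [apply (peqv_tmap_Some _ _ _ A) | apply (peqv_tmap_Some _ _ _ B)].
Defined.

Definition dup_fold (y : gen P) (o : option (gen P)) := match o with Some p => p | None => y end.

Lemma tmap_dup_fold_Some y t : tmap (dup_fold y) (tmap Some t) = t.
Proof. rewrite tmap_comp. apply tmap_id. Qed.

Definition dup_mor (y : gen P) (Hd : gdim P y = gdim P x)
  (Hs : forall k, gdim P x = S k -> peqv P k (gsrc P x) (gsrc P y) /\ peqv P k (gtgt P x) (gtgt P y)) :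
  PolMor pol_dup P.
Proof.
  refine (@Build_PolMor n pol_dup P (dup_fold y) _ _ _).
  - intros [p|]; simpl; auto.
  - intros [p|] k E; simpl in *; rewrite tmap_dup_fold_Some.
    + exact (proj1 (@gwf n P p k E)).
    + exact (proj1 (Hs k E)).
  - intros [p|] k E; simpl in *; rewrite tmap_dup_fold_Some.
    + exact (proj2 (@gwf n P p k E)).
    + exact (proj2 (Hs k E)).
Defined.
End Duplicate.

Section Monomorphisms.
Context {n : nbar} {P Q : Pol n} (F : PolMor P Q).

Lemma gens_injective_pol_mono : gens_injective F -> pol_mono F.
Proof.
  intros I R G H E x. apply (I (gdim P (G x))); auto.
  - apply gdim_le.
  - rewrite !pmap_dim. reflexivity.
Qed.

Lemma pol_mono_gens_injective : pol_mono F -> gens_injective F.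
Proof.
  intros M k _. induction k as [k IH] using (well_founded_induction lt_wf).
  intros x y Dx Dy E.
  assert (Hs : forall k', gdim P x = S k' ->
    peqv P k' (gsrc P x) (gsrc P y) /\ peqv P k' (gtgt P x) (gtgt P y)).
  { intros k' Ek'. apply (boundaries_of_equal_images F (S k')); auto; try congruence.
    intros p p' Hp Ep. apply (IH (gdim P p)); auto; try lia.
    rewrite <- (@pmap_dim _ _ _ F p'), <- Ep, (@pmap_dim _ _ _ F p). reflexivity. }
  refine (M (pol_dup P x) (dup_mor P x x eq_refl (@gwf n P x)) (dup_mor P x y ltac:(congruence) Hs)
    _ None).
  intros [p|]; [reflexivity | exact E].
Qed.

Lemma gens_injective_precat_mono : gens_injective F -> precat_mono (Fstar F).
Proof.
  intros I E G H Hyp x. specialize (Hyp x). simpl in *.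
  destruct Hyp as [D Hq]. split; auto.
  set (a := G x) in *. set (b := H x) in *.
  change (peqv Q (cdim P a) (tmap F (ctm P a)) (tmap F (ctm P b))) in Hq.
  set (K := Nat.max (tm_maxdim (gdim P) (ctm P a)) (tm_maxdim (gdim P) (ctm P b))).
  apply (eqv_reflect F (S K) K); auto.
  - intros p p' _ Ep. apply (I (gdim P p)); auto. apply gdim_le.
    rewrite <- (@pmap_dim _ _ _ F p'), <- Ep, (@pmap_dim _ _ _ F p). reflexivity.
  - eapply tm_below_mono; [|apply tm_below_maxdim]. unfold K; lia.
  - eapply tm_below_mono; [|apply tm_below_maxdim]. unfold K; lia.
Qed.

Lemma precat_mono_pol_mono : precat_mono (Fstar F) -> pol_mono F.
Proof.
  intros M R G H E x.
  assert (Hyp : forall e, ceq (Pstar Q) (Fstar F (Fstar G e)) (Fstar F (Fstar H e))).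
  { intros e. simpl. split; [reflexivity|].
    change (peqv Q (cdim R e) (tmap F (tmap G (ctm R e))) (tmap F (tmap H (ctm R e)))).
    rewrite !tmap_comp. rewrite (tmap_ext (fun x => F (G x)) (fun x => F (H x))) by auto.
    rewrite <- tmap_comp. exact (cwf Q (fcell F (fcell H e))). }
  pose (e := exist (fun p : nat * tm (gen R) => peqv R (fst p) (snd p) (snd p) /\ leN (fst p) n)
              (gdim R x, tgen x) (conj (gen_wf R x) (@gdim_le n R x)) : pcell R).
  destruct (M (Pstar R) (Fstar G) (Fstar H) Hyp e) as [_ X].
  exact (peqv_tgen_inj P _ _ _ X).
Qed.

End Monomorphisms.

Theorem proposition2p10 (n : nbar) (P Q : Pol n) (F : PolMor P Q) :
  (pol_mono F <-> gens_injective F) /\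
  (gens_injective F <-> precat_mono (Fstar F)).
Proof.
  split; split.
  - apply pol_mono_gens_injective.
  - apply gens_injective_pol_mono.
  - apply gens_injective_precat_mono.
  - intros M. apply pol_mono_gens_injective, precat_mono_pol_mono, M.
Qed.
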